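(* For every integer $n$ with $1\le n \leq 5$, the quotient $\mathbb{Z}[\operatorname{SL}_2(\mathbb{Z})]/((u-1)^n)$ of the group ring by the two-sided ideal generated by $(u-1)^n$ is a finitely generated $\mathbb{Z}$-module.
   Context: $u = \begin{pmatrix}1 & 1 \\ 0 & 1\end{pmatrix}\in\operatorname{SL}_2(\mathbb{Z})$, and $\mathbb{Z}[\operatorname{SL}_2(\mathbb{Z})]$ is the integral group ring of the abstract group $\operatorname{SL}_2(\mathbb{Z})$. *)

From HB Require Import structures.
From mathcomp Require Import all_boot all_order all_algebra.
Set Implicit Arguments. Unset Strict Implicit. Unset Printing Implicit Defensive.
Import Order.TTheory GRing.Theory Num.Theory.
Local Open Scope ring_scope.

Notation M2 := 'M[int]_2.
Definition inSL2 (A : M2) : bool := \det A == 1.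

(* Elements of the integral group ring Z[SL_2(Z)] are represented as finite
   formal sums  sum_i c_i [g_i]  (a list of pairs (c_i, g_i)), with all g_i
   in SL_2(Z). *)
Definition GR := seq (int * M2).

Definition inGR (r : GR) : bool := all (fun p => inSL2 p.2) r.

Definition coef (r : GR) (g : M2) : int := \sum_(p <- r | p.2 == g) p.1.

Definition gr_eq (r s : GR) : Prop := forall g : M2, coef r g = coef s g.

Definition gr_add (r s : GR) : GR := r ++ s.
Definition gr_scale (c : int) (r : GR) : GR := [seq (c * p.1, p.2) | p <- r].
Definition gr_sub (r s : GR) : GR := gr_add r (gr_scale (-1) s).
Definition gr_mul (r s : GR) : GR := [seq (p.1 * q.1, p.2 *m q.2) | p <- r, q <- s].
Definition gr_one : GR := [:: (1, 1%:M)].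
Definition gr_of (g : M2) : GR := [:: (1, g)].
Definition gr_pow (n : nat) (x : GR) : GR := iter n (gr_mul x) gr_one.

Definition gr_lincomb (cs : seq int) (gens : seq GR) : GR :=
  flatten [seq gr_scale c.1 c.2 | c <- zip cs gens].

(* r lies in the two-sided ideal generated by x: r = sum_k c_k g_k x h_k
   with c_k in Z and g_k, h_k in SL_2(Z) (these span the two-sided ideal
   as an abelian group). *)
Definition in_ideal2 (x r : GR) : Prop :=
  exists l : seq (int * M2 * M2),
    all (fun t => inSL2 t.1.2 && inSL2 t.2) l /\
    gr_eq r (flatten [seq gr_scale t.1.1 (gr_mul (gr_of t.1.2) (gr_mul x (gr_of t.2)))
                     | t <- l]).

Definition quotient_fg (x : GR) : Prop :=
  exists gens : seq GR,
    all inGR gens /\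
    forall r : GR, inGR r ->
      exists cs : seq int, size cs = size gens /\
        in_ideal2 x (gr_sub r (gr_lincomb cs gens)).

Definition u : M2 := \matrix_(i < 2, j < 2) (if (i <= j)%N then 1 else 0).

Definition u_minus_1 : GR := [:: (1, u); (-1, 1%:M)].

(* If the Z-span of the
   classes of a finite set W of group elements contains 1 and is stable under
   left multiplication by S and T^{+-1}, which generate SL_2(Z) as a monoid,
   then it contains every group element and is the whole quotient.  For n <= 5
   such a W is given explicitly, together with a certificate of stability: a
   sequence of pivots, each adding to the span an element h for which some
   g X y (g, y in SL_2(Z)) has coefficient +-1 at h and all the rest of its
   support already in the span.  The certificates are checked by evaluation. *)

From Stdlib Require Import BinInt FMapPositive.
From mathcomp Require Import all_boot all_order all_algebra.
From mathcomp Require Import ring zify ssrZ.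
Set Implicit Arguments. Unset Strict Implicit. Unset Printing Implicit Defensive.
Import Order.TTheory GRing.Theory Num.Theory.
Local Open Scope ring_scope.

Definition mx22 (a b c d : int) : M2 :=
  \matrix_(i < 2, j < 2) (if i == 0 then (if j == 0 then a else b)
                          else (if j == 0 then c else d)).

Lemma mx22E (g : M2) : g = mx22 (g 0 0) (g 0 1) (g 1 0) (g 1 1).
Proof.
apply/matrixP=> i j; rewrite mxE.
by case: i => [[|[|//]] Hi]; case: j => [[|[|//]] Hj] /=;
  congr (g _ _); apply: val_inj.
Qed.

Lemma mx22_1 : mx22 1 0 0 1 = 1%:M.
Proof.
apply/matrixP=> i j; rewrite !mxE.
by case: i => [[|[|//]] Hi]; case: j => [[|[|//]] Hj].
Qed.

Lemma mul_mx22 a b c d a' b' c' d' :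
  mx22 a b c d *m mx22 a' b' c' d' =
  mx22 (a * a' + b * c') (a * b' + b * d') (c * a' + d * c') (c * b' + d * d').
Proof.
apply/matrixP=> i j; rewrite !mxE !big_ord_recl big_ord0 !mxE addr0 /=.
by case: i => [[|[|//]] Hi]; case: j => [[|[|//]] Hj].
Qed.

Lemma det_mx22 a b c d : \det (mx22 a b c d) = a * d - b * c.
Proof.
rewrite (expand_det_row _ 0) !big_ord_recl big_ord0 /cofactor !det_mx11 !mxE /=.
by rewrite !expr0 !expr1 !mul1r addr0 mulN1r mulrN.
Qed.

Lemma eq_mx22 a b c d a' b' c' d' :
  (mx22 a b c d == mx22 a' b' c' d') = [&& a == a', b == b', c == c' & d == d'].
Proof.
apply/eqP/idP => [/matrixP E|/and4P[/eqP-> /eqP-> /eqP-> /eqP->] //].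
have := E 0 0; have := E 0 1; have := E 1 0; have := E 1 1.
by rewrite !mxE /= => -> -> -> ->; rewrite !eqxx.
Qed.

Definition mxS : M2 := mx22 0 (-1) 1 0.
Definition mxT (k : int) : M2 := mx22 1 k 0 1.

Definition SL2_generators : seq M2 := [:: mxS; mxT 1; mxT (-1)].

Lemma mxT1 : mxT 1 = u.
Proof.
apply/matrixP=> i j; rewrite !mxE.
by case: i => [[|[|//]] Hi]; case: j => [[|[|//]] Hj].
Qed.

Lemma mxT0 : mxT 0 = 1%:M.
Proof. exact: mx22_1. Qed.

Lemma mxTD k l : mxT (k + l) = mxT k *m mxT l.
Proof. by rewrite mul_mx22; congr mx22; ring. Qed.

Section SL2Induction.

Variable P : M2 -> Prop.
Hypothesis P1 : P 1%:M.
Hypothesis PS : forall g, P g -> P (mxS *m g).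
Hypothesis PT : forall g, P g -> P (mxT 1 *m g).
Hypothesis PTV : forall g, P g -> P (mxT (-1) *m g).

Lemma SL2_ind_shear k g : P g -> P (mxT k *m g).
Proof.
have Tnat m : P g -> P (mxT m%:Z *m g) /\ P (mxT (- m%:Z) *m g).
  elim: m => [|m IHm] Pg; first by rewrite oppr0 mxT0 mul1mx.
  have [PTm PTVm] := IHm Pg; rewrite intS opprD.
  by rewrite !mxTD -!mulmxA; split; [exact: PT | exact: PTV].
by case: k => m Pg; [case: (Tnat m Pg) | rewrite NegzE; case: (Tnat m.+1 Pg)].
Qed.

Lemma SL2_ind_upper a b d : a * d = 1 -> P (mx22 a b 0 d).
Proof.
move=> ad1; have /eqP := congr1 absz ad1; rewrite abszM muln_eq1 => /andP[/eqP a1 _].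
have a_pm1 : a = 1 \/ a = -1 by lia.
move: ad1; case: a_pm1 => -> ad1.
  by rewrite mul1r in ad1; rewrite ad1 -[mx22 1 b 0 1]mulmx1; apply: SL2_ind_shear.
have -> : d = -1 by rewrite -ad1 mulN1r opprK.
have := SL2_ind_shear (- b) (PS (PS P1)).
by rewrite -mx22_1 !mul_mx22; congr P; congr mx22; ring.
Qed.

Lemma SL2_ind g : inSL2 g -> P g.
Proof.
suff SL2_ind_bound N : forall a b c d : int,
    (absz c <= N)%N -> a * d - b * c = 1 -> P (mx22 a b c d).
  by rewrite /inSL2 [g]mx22E det_mx22 => /eqP; apply: SL2_ind_bound.
have P_c0 (a b c d : int) : c = 0 -> a * d - b * c = 1 -> P (mx22 a b c d).
  by move=> ->; rewrite mulr0 subr0; apply: SL2_ind_upper.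
elim: N => [|N IHN] a b c d cN det1; first by apply: P_c0 => //; lia.
have [c0|c_neq0] := eqVneq c 0; first exact: P_c0.
(* With a = q c + r, the matrix is T^q S^-1 g' where g' has lower-left entry r. *)
set q := (a %/ c)%Z; set r := (a %% c)%Z.
have a_qr : a = q * c + r by apply: divz_eq.
have rN : (absz r <= N)%N by have := ltz_mod a c_neq0; have := modz_ge0 a c_neq0; lia.
have := IHN (- c) (- d) r (b - q * d) rN.
have -> : - c * (b - q * d) - - d * r = 1 by rewrite -det1 a_qr; ring.
move=> /(_ erefl) /PS /PS /PS /(SL2_ind_shear q).
by rewrite !mul_mx22 a_qr; congr P; congr mx22; ring.
Qed.

End SL2Induction.

Lemma coef_nil g : coef [::] g = 0.
Proof. by rewrite /coef big_nil. Qed.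

Lemma coef_cons p r g : coef (p :: r) g = (if p.2 == g then p.1 else 0) + coef r g.
Proof. by rewrite /coef big_cons; case: ifP; rewrite ?add0r. Qed.

Lemma coef_cat r s g : coef (r ++ s) g = coef r g + coef s g.
Proof. by rewrite /coef big_cat. Qed.

Lemma coef_scale c r g : coef (gr_scale c r) g = c * coef r g.
Proof.
rewrite /coef big_map big_distrr /= big_mkcond [RHS]big_mkcond.
by apply: eq_bigr => p _; case: ifP; rewrite ?mulr0.
Qed.

Lemma coef_sub r s g : coef (gr_sub r s) g = coef r g - coef s g.
Proof. by rewrite coef_cat coef_scale mulN1r. Qed.

Lemma coef_flatten rs g : coef (flatten rs) g = \sum_(r <- rs) coef r g.
Proof.
elim: rs => [|r rs IHrs]; first by rewrite big_nil coef_nil.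
by rewrite /= coef_cat IHrs big_cons.
Qed.

Definition gr_lmul (s : M2) (r : GR) : GR := [seq (p.1, s *m p.2) | p <- r].

Lemma gr_mul_ofE s r : gr_mul (gr_of s) r = gr_lmul s r.
Proof. by rewrite /gr_mul /= cats0; apply: eq_map => p; rewrite mul1r. Qed.

Lemma unitmx_SL2 s : inSL2 s -> s \in unitmx.
Proof. by rewrite /inSL2 unitmxE => /eqP ->; rewrite unitr1. Qed.

Lemma coef_lmul s r g : s \in unitmx -> coef (gr_lmul s r) g = coef r (invmx s *m g).
Proof.
move=> s_unit; rewrite /coef big_map; apply: eq_bigl => p /=.
by apply/eqP/eqP => [<-|->]; [rewrite mulKmx | rewrite mulKVmx].
Qed.

Section Ideal.

Variable X : GR.
Local Notation J := (in_ideal2 X).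

Lemma in_ideal2_gr_eq r s : gr_eq r s -> J r -> J s.
Proof. by move=> rs [l [Hl Er]]; exists l; split=> // g; rewrite -rs. Qed.

Lemma in_ideal2_nil : J [::].
Proof. by exists [::]. Qed.

Lemma in_ideal2_cat r s : J r -> J s -> J (r ++ s).
Proof.
move=> [l1 [H1 E1]] [l2 [H2 E2]]; exists (l1 ++ l2).
by rewrite all_cat H1 H2; split=> // g; rewrite coef_cat E1 E2 map_cat flatten_cat coef_cat.
Qed.

Lemma in_ideal2_scale c r : J r -> J (gr_scale c r).
Proof.
move=> [l [Hl Er]]; exists [seq (c * t.1.1, t.1.2, t.2) | t <- l].
rewrite all_map; split=> // g; rewrite coef_scale Er !coef_flatten big_distrr.
by rewrite -map_comp !big_map; apply: eq_bigr => t _; rewrite /= !coef_scale mulrA.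
Qed.

Lemma in_ideal2_lmul s r : inSL2 s -> J r -> J (gr_lmul s r).
Proof.
move=> s_SL2 [l [Hl Er]]; exists [seq (t.1.1, s *m t.1.2, t.2) | t <- l]; split.
  rewrite all_map; apply/allP => t /(allP Hl) /andP[H1 H2] /=.
  by rewrite H2 andbT /inSL2 det_mulmx (eqP s_SL2) (eqP H1) mulr1.
move=> g; rewrite coef_lmul ?unitmx_SL2 // Er -coef_lmul ?unitmx_SL2 //.
congr coef; rewrite /gr_lmul map_flatten -!map_comp; congr flatten; apply: eq_map => t /=.
by rewrite !gr_mul_ofE /gr_lmul /gr_scale -!map_comp; apply: eq_map => p /=; rewrite mulmxA.
Qed.

Lemma in_ideal2_gen g y : inSL2 g -> inSL2 y -> J (gr_mul (gr_of g) (gr_mul X (gr_of y))).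
Proof.
by move=> g_SL2 y_SL2; exists [:: (1, g, y)]; rewrite /= g_SL2 y_SL2; split=> // h;
  rewrite cats0 coef_scale mul1r.
Qed.

End Ideal.

Definition addseq (cs1 cs2 : seq int) : seq int := [seq p.1 + p.2 | p <- zip cs1 cs2].

Lemma size_addseq cs1 cs2 n : size cs1 = n -> size cs2 = n -> size (addseq cs1 cs2) = n.
Proof. by move=> <- eq_sz; rewrite size_map size_zip eq_sz minnn. Qed.

Lemma coef_lincomb_add W cs1 cs2 g : size cs1 = size W -> size cs2 = size W ->
  coef (gr_lincomb (addseq cs1 cs2) W) g =
  coef (gr_lincomb cs1 W) g + coef (gr_lincomb cs2 W) g.
Proof.
elim: W cs1 cs2 => [|w W IHW] [|c1 cs1] [|c2 cs2] //=; first by rewrite !coef_nil addr0.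
move=> [sz1] [sz2]; rewrite !coef_cat !coef_scale IHW // mulrDl.
by rewrite addrACA.
Qed.

Lemma coef_lincomb_scale W c cs g :
  coef (gr_lincomb [seq c * x | x <- cs] W) g = c * coef (gr_lincomb cs W) g.
Proof.
elim: W cs => [|w W IHW] [|c1 cs] /=; rewrite ?coef_nil ?mulr0 //.
by rewrite !coef_cat !coef_scale IHW mulrDr mulrA.
Qed.

Lemma coef_lincomb0 W k g : coef (gr_lincomb (nseq k 0) W) g = 0.
Proof.
elim: W k => [|w W IHW] [|k] /=; rewrite ?coef_nil //.
by rewrite coef_cat coef_scale IHW mul0r addr0.
Qed.

Lemma lincomb_mem W w : w \in W ->
  exists2 cs, size cs = size W & forall g, coef (gr_lincomb cs W) g = coef w g.
Proof.
elim: W => [|a W IHW] //; rewrite in_cons => /orP[/eqP ->|/IHW [cs sz_cs E]].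
  exists (1 :: nseq (size W) 0); first by rewrite /= size_nseq.
  by move=> g; rewrite /= coef_cat coef_scale coef_lincomb0 mul1r addr0.
exists (0 :: cs); first by rewrite /= sz_cs.
by move=> g; rewrite /= coef_cat coef_scale E mul0r add0r.
Qed.

Definition in_span_mod (X : GR) (W : seq GR) (r : GR) : Prop :=
  exists cs : seq int, size cs = size W /\ in_ideal2 X (gr_sub r (gr_lincomb cs W)).

Section SpanModIdeal.

Variables (X : GR) (W : seq GR).
Local Notation J := (in_ideal2 X).
Local Notation V := (in_span_mod X W).

Lemma in_span_mod_gr_eq r s : gr_eq r s -> V r -> V s.
Proof.
move=> rs [cs [sz_cs Jr]]; exists cs; split=> //; apply: in_ideal2_gr_eq Jr => g.
by rewrite !coef_sub rs.
Qed.

Lemma in_span_mod_ideal r : J r -> V r.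
Proof.
move=> Jr; exists (nseq (size W) 0); rewrite size_nseq; split=> //.
by apply: in_ideal2_gr_eq Jr => g; rewrite coef_sub coef_lincomb0 subr0.
Qed.

Lemma in_span_mod_nil : V [::].
Proof. exact/in_span_mod_ideal/in_ideal2_nil. Qed.

Lemma in_span_mod_cat r s : V r -> V s -> V (r ++ s).
Proof.
move=> [c1 [sz1 J1]] [c2 [sz2 J2]]; exists (addseq c1 c2); split.
  exact: size_addseq.
apply: in_ideal2_gr_eq (in_ideal2_cat J1 J2) => g.
by rewrite !(coef_cat, coef_sub, coef_scale) coef_lincomb_add //; ring.
Qed.

Lemma in_span_mod_scale c r : V r -> V (gr_scale c r).
Proof.
move=> [cs [sz_cs Jr]]; exists [seq c * x | x <- cs]; rewrite size_map; split=> //.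
apply: in_ideal2_gr_eq (in_ideal2_scale c Jr) => g.
by rewrite coef_scale !coef_sub coef_scale coef_lincomb_scale mulrBr.
Qed.

Lemma in_span_mod_mem w : w \in W -> V w.
Proof.
move=> /lincomb_mem [cs sz_cs E]; exists cs; split=> //.
by apply: in_ideal2_gr_eq (in_ideal2_nil X) => g; rewrite coef_sub E subrr coef_nil.
Qed.

Lemma in_span_mod_support r : (forall p, p \in r -> V (gr_of p.2)) -> V r.
Proof.
elim: r => [|p r IHr] Vr; first exact: in_span_mod_nil.
have Vp : V (gr_scale p.1 (gr_of p.2)) by apply/in_span_mod_scale/Vr; rewrite mem_head.
have {}Vr : V r by apply: IHr => q q_r; apply: Vr; rewrite in_cons q_r orbT.
apply: in_span_mod_gr_eq (in_span_mod_cat Vp Vr) => g.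
by rewrite coef_cat coef_scale !coef_cons coef_nil /=; case: ifP => _; ring.
Qed.

Lemma in_span_mod_pivot R h : J R -> coef R h ^+ 2 = 1 ->
  (forall p, p \in R -> p.2 != h -> V (gr_of p.2)) -> V (gr_of h).
Proof.
move=> JR unit_h VR; set R' := [seq p <- R | p.2 != h].
have VR' : V R'.
  by apply: in_span_mod_support => p; rewrite mem_filter => /andP[p_neq_h p_R]; exact: VR.
have := in_span_mod_scale (coef R h)
  (in_span_mod_cat (in_span_mod_ideal JR) (in_span_mod_scale (-1) VR')).
apply: in_span_mod_gr_eq => g.
have coef_R' : coef R' g = if g == h then 0 else coef R g.
  rewrite /coef /R' big_filter_cond; case: eqP => [->|g_neq_h].
    by rewrite big_pred0 // => p; rewrite andNb.
  by apply: eq_bigl => p; case: (eqVneq p.2 g) => [->|]; rewrite ?andbF ?andbT //; apply/eqP.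
rewrite coef_scale coef_cat coef_scale coef_R' coef_cons coef_nil /=.
by case: (eqVneq g h) => [->|_]; [rewrite mulr0 !addr0 -expr2 unit_h | ring].
Qed.

Lemma in_span_mod_lmul s r :
  inSL2 s -> (forall w, w \in W -> V (gr_lmul s w)) -> V r -> V (gr_lmul s r).
Proof.
move=> s_SL2 VsW [cs [sz_cs Jr]].
have VsJ : V (gr_lmul s (gr_sub r (gr_lincomb cs W))).
  exact/in_span_mod_ideal/in_ideal2_lmul.
have VsW' W' cs' : all (mem W) W' -> V (gr_lmul s (gr_lincomb cs' W')).
  elim: W' cs' => [|w W' IHW'] [|c cs'] /=; try by move=> _; apply: in_span_mod_nil.
  move=> /andP[w_W W'_W].
  rewrite /gr_lmul map_cat; apply: in_span_mod_cat; last exact: IHW'.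
  have -> : [seq (p.1, s *m p.2) | p <- gr_scale c w] = gr_scale c (gr_lmul s w).
    by rewrite /gr_scale /gr_lmul -!map_comp.
  exact/in_span_mod_scale/VsW.
have VsW_cs : V (gr_lmul s (gr_lincomb cs W)) by apply: VsW'; apply/allP.
apply: in_span_mod_gr_eq (in_span_mod_cat VsJ VsW_cs) => g.
by rewrite coef_cat !coef_lmul ?unitmx_SL2 // coef_sub subrK.
Qed.

End SpanModIdeal.

Lemma in_span_mod_SL2 X W :
  in_span_mod X W (gr_of 1%:M) ->
  (forall s w, s \in SL2_generators -> w \in W -> in_span_mod X W (gr_lmul s w)) ->
  forall g, inSL2 g -> in_span_mod X W (gr_of g).
Proof.
move=> V1 VsW.
have VsV s g : s \in SL2_generators ->
    in_span_mod X W (gr_of g) -> in_span_mod X W (gr_of (s *m g)).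
  move=> s_gen; apply: in_span_mod_lmul => [|w]; last exact: VsW.
  by move: s_gen; rewrite !inE => /or3P[]/eqP->; rewrite /inSL2 /mxS /mxT det_mx22.
by apply: SL2_ind => // g; apply: VsV; rewrite !inE eqxx ?orbT.
Qed.

Lemma quotient_fg_generators X W : all inGR W ->
  in_span_mod X W (gr_of 1%:M) ->
  (forall s w, s \in SL2_generators -> w \in W -> in_span_mod X W (gr_lmul s w)) ->
  quotient_fg X.
Proof.
move=> W_SL2 V1 VsW; exists W; split=> // r r_SL2.
apply: in_span_mod_support => p p_r.
exact/(in_span_mod_SL2 V1 VsW)/(allP r_SL2).
Qed.

Definition zmx := (Z * Z * Z * Z)%type.
Definition Zmx (a b c d : Z) : zmx := (a, b, c, d).
Arguments Zmx (_ _ _ _)%_Z_scope.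

Section Certificates.
Local Open Scope Z_scope.

Definition zmx_mul (x y : zmx) : zmx :=
  let '(a, b, c, d) := x in let '(a', b', c', d') := y in
  Zmx (a * a' + b * c') (a * b' + b * d') (c * a' + d * c') (c * b' + d * d').
Definition zmx_det (x : zmx) : Z := let '(a, b, c, d) := x in a * d - b * c.

Definition zmx_unimodular (x : zmx) : bool := zmx_det x == 1.

Definition zmx1 : zmx := Zmx 1 0 0 1.
Definition zmxS : zmx := Zmx 0 (-1) 1 0.
Definition zmxT1 : zmx := Zmx 1 1 0 1.
Definition zmxTV : zmx := Zmx 1 (-1) 0 1.

Definition zmx_generators : seq zmx := [:: zmxS; zmxT1; zmxTV].

Definition zgr := seq (Z * zmx).
Definition zgr_mul (r s : zgr) : zgr := [seq (p.1 * q.1, zmx_mul p.2 q.2) | p <- r, q <- s].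
Definition zgr_pow (n : nat) (x : zgr) : zgr := iter n (zgr_mul x) [:: (1, zmx1)].
Definition zgr_u_minus_1 : zgr := [:: (1, zmxT1); (-1, zmx1)].
Definition zgr_coef (r : zgr) (h : zmx) : Z :=
  foldr (fun p c => if p.2 == h then p.1 + c else c) 0 r.

(* Collisions (outside the entry range (-4096, 4096)) are harmless: membership
   compares the stored matrix with the queried one. *)
Definition zmx_key (x : zmx) : positive :=
  let '(a, b, c, d) := x in
  Z.to_pos (1 + (a + 4096) + 8192 * ((b + 4096) + 8192 * ((c + 4096) + 8192 * (d + 4096)))).

Definition zmx_set := PositiveMap.t zmx.
Definition zmx_set_add (x : zmx) (m : zmx_set) : zmx_set := PositiveMap.add (zmx_key x) x m.
Definition zmx_set_mem (m : zmx_set) (x : zmx) : bool :=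
  if PositiveMap.find (zmx_key x) m is Some y then y == x else false.

(* A pivot [(h, g, y)] certifies [h] through the ideal element [g (u - 1)^n y]. *)
Definition pivot := (zmx * zmx * zmx)%type.

Definition check_pivot (X : zgr) (known : zmx_set) (pv : pivot) : bool :=
  let '(h, g, y) := pv in
  let R := zgr_mul [:: (1, g)] (zgr_mul X [:: (1, y)]) in
  [&& zmx_unimodular g, zmx_unimodular y, zgr_coef R h \in [:: 1; -1]
    & all (fun p => (p.2 == h) || zmx_set_mem known p.2) R].

Fixpoint run_pivots (X : zgr) (known : zmx_set) (pvs : seq pivot) : option zmx_set :=
  if pvs is pv :: pvs' then
    if check_pivot X known pv then run_pivots X (zmx_set_add pv.1.1 known) pvs' else None
  else Some known.

Definition check_certificate (n : nat) (W : seq zmx) (pvs : seq pivot) : bool :=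
  let known0 := foldr zmx_set_add (PositiveMap.empty zmx) W in
  if run_pivots (zgr_pow n zgr_u_minus_1) known0 pvs is Some known then
    zmx_set_mem known zmx1 &&
    all (fun w => zmx_unimodular w &&
                  all (fun s => zmx_set_mem known (zmx_mul s w)) zmx_generators) W
  else false.

End Certificates.

Definition M2_of_zmx (x : zmx) : M2 :=
  let '(a, b, c, d) := x in mx22 (int_of_Z a) (int_of_Z b) (int_of_Z c) (int_of_Z d).

Lemma M2_of_zmx_mul x y : M2_of_zmx (zmx_mul x y) = M2_of_zmx x *m M2_of_zmx y.
Proof.
case: x => [[[a b] c] d]; case: y => [[[a' b'] c'] d'].
by rewrite /= mul_mx22 !rmorphD !rmorphM.
Qed.

Lemma det_M2_of_zmx x : \det (M2_of_zmx x) = int_of_Z (zmx_det x).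
Proof. by case: x => [[[a b] c] d]; rewrite /= det_mx22 rmorphB !rmorphM. Qed.

Lemma inSL2_M2_of_zmx x : zmx_unimodular x -> inSL2 (M2_of_zmx x).
Proof. by move=> /eqP det1; rewrite /inSL2 det_M2_of_zmx det1. Qed.

Lemma M2_of_zmx_inj : injective M2_of_zmx.
Proof.
move=> [[[a b] c] d] [[[a' b'] c'] d'] /eqP; rewrite /= eq_mx22.
by rewrite !(inj_eq (can_inj int_of_ZK)) => /and4P[/eqP-> /eqP-> /eqP-> /eqP->].
Qed.

Definition GR_of_zgr (r : zgr) : GR := [seq (int_of_Z p.1, M2_of_zmx p.2) | p <- r].

Lemma GR_of_zgr_mul r s : GR_of_zgr (zgr_mul r s) = gr_mul (GR_of_zgr r) (GR_of_zgr s).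
Proof.
rewrite /GR_of_zgr /zgr_mul /gr_mul map_allpairs allpairs_mapl allpairs_mapr.
by apply: eq_allpairs => p q; rewrite /= rmorphM M2_of_zmx_mul.
Qed.

Lemma GR_of_zgr_pow n : GR_of_zgr (zgr_pow n zgr_u_minus_1) = gr_pow n u_minus_1.
Proof.
elim: n => [|n IHn]; first by rewrite /= /gr_one -mx22_1.
rewrite /= GR_of_zgr_mul -/(zgr_pow n _) IHn.
by rewrite /u_minus_1 -mx22_1 -mxT1.
Qed.

Lemma zgr_coefE r h : int_of_Z (zgr_coef r h) = coef (GR_of_zgr r) (M2_of_zmx h).
Proof.
elim: r => [|p r IHr]; first by rewrite coef_nil.
rewrite /= coef_cons -IHr (inj_eq M2_of_zmx_inj).
by case: ifP; rewrite ?rmorphD ?add0r.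
Qed.

Section CertificateSoundness.

Variables (n : nat) (W : seq zmx).
Local Notation X := (gr_pow n u_minus_1).
Local Notation WG := [seq gr_of (M2_of_zmx w) | w <- W].
Local Notation V := (in_span_mod X WG).

Definition zmx_set_in_span (m : zmx_set) : Prop :=
  forall k v, PositiveMap.find k m = Some v -> V (gr_of (M2_of_zmx v)).

Lemma zmx_set_mem_in_span m x : zmx_set_in_span m -> zmx_set_mem m x -> V (gr_of (M2_of_zmx x)).
Proof.
rewrite /zmx_set_mem; case E: (PositiveMap.find _ _) => [y|] // Vm /eqP y_x.
by rewrite -y_x; apply: Vm E.
Qed.

Lemma zmx_set_add_in_span m x :
  zmx_set_in_span m -> V (gr_of (M2_of_zmx x)) -> zmx_set_in_span (zmx_set_add x m).
Proof.
move=> Vm Vx k v; rewrite /zmx_set_add; case: (Pos.eq_dec k (zmx_key x)) => [->|k_neq].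
  by rewrite PositiveMap.gss => -[<-].
by rewrite PositiveMap.gso //; apply: Vm.
Qed.

Lemma generators_in_span : zmx_set_in_span (foldr zmx_set_add (PositiveMap.empty zmx) W).
Proof.
have: {subset W <= W} by [].
elim: {-2}W => [|w W' IHW'] /= W'_W; first by move=> k v; rewrite PositiveMap.gempty.
apply: zmx_set_add_in_span; first by apply: IHW' => x x_W'; apply: W'_W; rewrite inE x_W' orbT.
by apply/in_span_mod_mem/map_f/W'_W; rewrite mem_head.
Qed.

Lemma check_pivot_sound known pv : zmx_set_in_span known ->
  check_pivot (zgr_pow n zgr_u_minus_1) known pv -> V (gr_of (M2_of_zmx pv.1.1)).
Proof.
case: pv => [[h g] y] /= Vknown /and4P[g_SL2 y_SL2 unit_h support_known].
set R := zgr_mul _ _ in unit_h support_known.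
have GR_R : GR_of_zgr R = gr_mul (gr_of (M2_of_zmx g)) (gr_mul X (gr_of (M2_of_zmx y))).
  by rewrite !GR_of_zgr_mul GR_of_zgr_pow.
apply: (@in_span_mod_pivot _ _ (GR_of_zgr R)).
- by rewrite GR_R; apply: in_ideal2_gen; apply: inSL2_M2_of_zmx.
- by rewrite -zgr_coefE; move: unit_h; rewrite !inE => /orP[]/eqP->.
- move=> _ /mapP[p p_R ->] /= p_neq_h.
  case/orP: (allP support_known p p_R) => [p_h|]; last exact: zmx_set_mem_in_span.
  by rewrite (eqP p_h) eqxx in p_neq_h.
Qed.

Lemma run_pivots_sound pvs known known' : zmx_set_in_span known ->
  run_pivots (zgr_pow n zgr_u_minus_1) known pvs = Some known' -> zmx_set_in_span known'.
Proof.
elim: pvs known => [|pv pvs IHpvs] known Vknown /=; first by move=> [<-].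
case ok_pv: check_pivot => //; apply: IHpvs; apply: zmx_set_add_in_span => //.
exact: check_pivot_sound ok_pv.
Qed.

Lemma check_certificate_sound pvs : check_certificate n W pvs -> quotient_fg X.
Proof.
rewrite /check_certificate; case E: run_pivots => [known|] // /andP[known1 W_ok].
have Vknown := run_pivots_sound generators_in_span E.
apply: (@quotient_fg_generators _ WG).
- apply/allP => _ /mapP[w w_W ->]; rewrite /inGR /= andbT.
  by case/andP: (allP W_ok w w_W) => /inSL2_M2_of_zmx.
- by rewrite -mx22_1; apply: zmx_set_mem_in_span known1.
- move=> s _ s_gen /mapP[w w_W ->]; case/andP: (allP W_ok w w_W) => _ /allP sw_known.
  have [zs zs_gen ->] : exists2 zs, zs \in zmx_generators & s = M2_of_zmx zs.
    by move: s_gen; rewrite !inE => /or3P[]/eqP->;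
      [exists zmxS | exists zmxT1 | exists zmxTV]; rewrite ?inE ?eqxx ?orbT.
  by have := zmx_set_mem_in_span Vknown (sw_known zs zs_gen); rewrite M2_of_zmx_mul.
Qed.

End CertificateSoundness.

Definition generators_1 : seq zmx := [::
  Zmx (-1) (-1) 0 (-1); Zmx (-1) (-1) 1 0; Zmx (-1) 0 (-1) (-1); Zmx (-1) 0 0 (-1);
  Zmx (-1) 0 1 (-1); Zmx (-1) 1 (-1) 0; Zmx (-1) 1 0 (-1); Zmx 0 (-1) 1 (-1);
  Zmx 0 (-1) 1 0; Zmx 0 (-1) 1 1; Zmx 0 1 (-1) (-1); Zmx 0 1 (-1) 0;
  Zmx 0 1 (-1) 1; Zmx 1 (-1) 0 1; Zmx 1 (-1) 1 0; Zmx 1 0 (-1) 1;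
  Zmx 1 0 0 1; Zmx 1 0 1 1; Zmx 1 1 (-1) 0; Zmx 1 1 0 1].

Definition pivots_1 : seq pivot := [::
  (Zmx (-4) (-3) 3 2, Zmx 2 1 (-1) 0, Zmx (-3) (-2) 2 1);
  (Zmx (-4) (-1) 1 0, Zmx 2 1 (-1) 0, Zmx 1 1 (-2) (-1));
  (Zmx (-4) 1 3 (-1), Zmx 4 (-1) (-3) 1, Zmx (-1) 0 0 (-1));
  (Zmx (-3) (-2) (-4) (-3), Zmx 1 0 2 1, Zmx (-3) (-2) 2 1);
  (Zmx (-3) 1 (-4) 1, Zmx 1 0 2 1, Zmx (-3) 1 2 (-1));
  (Zmx (-2) (-3) 1 1, Zmx 1 1 (-1) 0, Zmx 0 1 (-1) (-2));
  (Zmx (-2) (-1) (-3) (-2), Zmx 1 (-1) 1 0, Zmx (-3) (-2) (-1) (-1));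
  (Zmx (-2) (-1) (-1) (-1), Zmx 0 (-1) 1 0, Zmx (-3) (-2) 2 1);
  (Zmx (-2) (-1) 1 0, Zmx 2 1 (-1) 0, Zmx (-1) 0 0 (-1));
  (Zmx (-2) 1 (-3) 1, Zmx 1 (-1) 1 0, Zmx (-3) 1 (-1) 0);
  (Zmx (-2) 1 (-1) 0, Zmx 0 (-1) 1 0, Zmx (-3) 1 2 (-1));
  (Zmx (-2) 1 1 (-1), Zmx 2 1 (-1) 0, Zmx (-1) 1 0 (-1));
  (Zmx (-2) 3 (-3) 4, Zmx 1 0 2 1, Zmx (-2) 3 1 (-2));
  (Zmx (-1) (-4) 1 3, Zmx 2 1 (-1) 0, Zmx (-1) (-3) 1 2);
  (Zmx (-1) (-3) (-1) (-4), Zmx 1 0 2 1, Zmx (-1) (-3) 1 2);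
  (Zmx (-1) (-2) (-1) (-3), Zmx 1 (-1) 1 0, Zmx (-1) (-3) 0 (-1));
  (Zmx (-1) (-2) 0 (-1), Zmx 0 (-1) 1 0, Zmx (-1) (-3) 1 2);
  (Zmx (-1) (-2) 1 1, Zmx 3 2 (-2) (-1), Zmx (-2) 1 1 (-1));
  (Zmx (-1) (-1) 4 3, Zmx 1 1 (-2) (-1), Zmx (-3) (-2) 2 1);
  (Zmx (-1) 0 4 (-1), Zmx 1 1 (-2) (-1), Zmx (-3) 1 2 (-1));
  (Zmx (-1) 1 3 (-4), Zmx 1 1 (-2) (-1), Zmx (-2) 3 1 (-2));
  (Zmx (-1) 2 (-2) 3, Zmx 1 (-1) 1 0, Zmx (-2) 3 (-1) 1);
  (Zmx (-1) 2 (-1) 1, Zmx 0 (-1) 1 0, Zmx (-2) 3 1 (-2));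
  (Zmx (-1) 2 0 (-1), Zmx 3 1 (-1) 0, Zmx 0 1 (-1) (-1));
  (Zmx (-1) 4 0 (-1), Zmx 2 1 (-1) 0, Zmx 1 (-1) (-1) 2);
  (Zmx 0 (-1) 1 4, Zmx 1 1 (-2) (-1), Zmx (-1) (-3) 1 2);
  (Zmx 1 (-2) 0 1, Zmx 2 1 (-1) 0, Zmx (-1) (-1) 1 0);
  (Zmx 1 (-2) 1 (-1), Zmx 1 1 (-1) 0, Zmx (-3) 4 2 (-3));
  (Zmx 1 2 (-1) (-1), Zmx 2 1 (-1) 0, Zmx 1 1 (-1) 0);
  (Zmx 1 2 0 1, Zmx 1 1 (-1) 0, Zmx (-1) (-4) 1 3);
  (Zmx 2 (-1) (-1) 1, Zmx 3 2 (-2) (-1), Zmx (-1) (-2) 1 1);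
  (Zmx 2 (-1) 1 0, Zmx 1 1 (-1) 0, Zmx (-4) 1 3 (-1));
  (Zmx 2 1 (-1) 0, Zmx 3 1 (-1) 0, Zmx 1 0 (-1) 1);
  (Zmx 2 1 1 1, Zmx 1 1 (-1) 0, Zmx (-4) (-3) 3 2)].

Definition generators_2 : seq zmx := [::
  Zmx (-1) (-1) 0 (-1); Zmx (-1) (-1) 1 0; Zmx (-1) 0 (-1) (-1); Zmx (-1) 0 0 (-1);
  Zmx (-1) 0 1 (-1); Zmx (-1) 1 (-1) 0; Zmx (-1) 1 0 (-1); Zmx 0 (-1) 1 (-1);
  Zmx 0 (-1) 1 0; Zmx 0 (-1) 1 1; Zmx 0 1 (-1) (-1); Zmx 0 1 (-1) 0;
  Zmx 0 1 (-1) 1; Zmx 1 (-1) 0 1; Zmx 1 (-1) 1 0; Zmx 1 0 (-1) 1;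
  Zmx 1 0 0 1; Zmx 1 0 1 1; Zmx 1 1 (-1) 0; Zmx 1 1 0 1].

Definition pivots_2 : seq pivot := [::
  (Zmx (-2) (-1) (-1) (-1), Zmx 1 0 0 1, Zmx 0 1 (-1) (-1));
  (Zmx (-2) (-1) 1 0, Zmx 1 0 0 1, Zmx (-2) (-1) 1 0);
  (Zmx (-2) 1 (-1) 0, Zmx 1 0 0 1, Zmx 0 1 (-1) 0);
  (Zmx (-2) 1 1 (-1), Zmx 1 1 (-1) 0, Zmx 1 1 (-1) 0);
  (Zmx (-1) (-2) 0 (-1), Zmx 1 0 0 1, Zmx (-1) 0 0 (-1));
  (Zmx (-1) (-2) 1 1, Zmx 1 1 (-1) 0, Zmx (-1) 1 0 (-1));
  (Zmx (-1) (-2) 2 3, Zmx 0 (-1) 1 0, Zmx 0 (-1) 1 2);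
  (Zmx (-1) (-1) 2 1, Zmx 1 1 (-1) 0, Zmx (-2) (-1) 1 0);
  (Zmx (-1) 0 (-2) (-1), Zmx 0 (-1) 1 0, Zmx (-2) (-1) 1 0);
  (Zmx (-1) 0 2 (-1), Zmx 1 1 (-2) (-1), Zmx (-1) 1 0 (-1));
  (Zmx (-1) 0 3 (-1), Zmx 0 (-1) 1 0, Zmx 1 (-1) 1 0);
  (Zmx (-1) 1 (-2) 1, Zmx 0 (-1) 1 0, Zmx (-2) 1 1 (-1));
  (Zmx (-1) 2 (-2) 3, Zmx 1 0 2 1, Zmx (-1) 2 0 (-1));
  (Zmx (-1) 2 (-1) 1, Zmx 1 0 0 1, Zmx 1 0 (-1) 1);
  (Zmx (-1) 2 0 (-1), Zmx 0 (-1) 1 0, Zmx (-2) 3 1 (-2));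
  (Zmx 0 1 (-1) (-2), Zmx 1 1 (-1) 0, Zmx 1 2 (-1) (-1));
  (Zmx 1 (-2) (-1) 3, Zmx 1 1 (-2) (-1), Zmx (-2) 1 1 (-1));
  (Zmx 1 (-2) 0 1, Zmx 1 1 (-1) 0, Zmx (-2) 1 1 (-1));
  (Zmx 1 (-2) 1 (-1), Zmx 0 (-1) 1 0, Zmx 1 (-1) (-1) 2);
  (Zmx 1 0 (-2) 1, Zmx 1 1 (-1) 0, Zmx 2 (-1) (-1) 1);
  (Zmx 1 1 (-2) (-1), Zmx 1 1 (-1) 0, Zmx 2 1 (-1) 0);
  (Zmx 1 2 (-2) (-3), Zmx 1 1 (-1) 0, Zmx 2 3 (-1) (-1));
  (Zmx 1 2 (-1) (-1), Zmx 1 1 (-1) 0, Zmx 1 (-1) 0 1);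
  (Zmx 1 2 0 1, Zmx 0 (-1) 1 0, Zmx 0 1 (-1) (-2));
  (Zmx 2 (-3) (-1) 2, Zmx 1 1 (-1) 0, Zmx (-1) 0 1 (-1));
  (Zmx 2 (-1) (-3) 2, Zmx 1 1 (-1) 0, Zmx 3 (-2) (-1) 1);
  (Zmx 2 (-1) (-1) 1, Zmx 1 1 (-1) 0, Zmx (-1) (-1) 1 0);
  (Zmx 2 (-1) 1 0, Zmx 0 (-1) 1 0, Zmx 1 0 (-2) 1);
  (Zmx 2 1 (-3) (-1), Zmx 1 1 (-1) 0, Zmx 3 1 (-1) 0);
  (Zmx 2 1 (-1) 0, Zmx 2 1 (-1) 0, Zmx 1 (-2) 0 1);
  (Zmx 2 1 1 1, Zmx 0 (-1) 1 0, Zmx 1 1 (-2) (-1))].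

Definition generators_3 : seq zmx := [::
  Zmx (-2) (-1) (-1) (-1); Zmx (-2) (-1) 1 0; Zmx (-2) 1 (-1) 0; Zmx (-2) 1 1 (-1);
  Zmx (-1) (-2) 0 (-1); Zmx (-1) (-2) 1 1; Zmx (-1) (-1) (-1) (-2); Zmx (-1) (-1) 0 (-1);
  Zmx (-1) (-1) 1 0; Zmx (-1) (-1) 2 1; Zmx (-1) 0 (-2) (-1); Zmx (-1) 0 (-1) (-1);
  Zmx (-1) 0 0 (-1); Zmx (-1) 0 1 (-1); Zmx (-1) 0 2 (-1); Zmx (-1) 1 (-2) 1;
  Zmx (-1) 1 (-1) 0; Zmx (-1) 1 0 (-1); Zmx (-1) 1 1 (-2); Zmx (-1) 2 (-1) 1;
  Zmx (-1) 2 0 (-1); Zmx 0 (-1) 1 (-2); Zmx 0 (-1) 1 (-1); Zmx 0 (-1) 1 0;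
  Zmx 0 (-1) 1 1; Zmx 0 (-1) 1 2; Zmx 0 1 (-1) (-2); Zmx 0 1 (-1) (-1);
  Zmx 0 1 (-1) 0; Zmx 0 1 (-1) 1; Zmx 0 1 (-1) 2; Zmx 1 (-2) 0 1;
  Zmx 1 (-2) 1 (-1); Zmx 1 (-1) (-1) 2; Zmx 1 (-1) 0 1; Zmx 1 (-1) 1 0;
  Zmx 1 (-1) 2 (-1); Zmx 1 0 (-2) 1; Zmx 1 0 (-1) 1; Zmx 1 0 0 1;
  Zmx 1 0 1 1; Zmx 1 0 2 1; Zmx 1 1 (-2) (-1); Zmx 1 1 (-1) 0;
  Zmx 1 1 0 1; Zmx 1 1 1 2; Zmx 1 2 (-1) (-1); Zmx 1 2 0 1;
  Zmx 2 (-1) (-1) 1; Zmx 2 (-1) 1 0; Zmx 2 1 (-1) 0; Zmx 2 1 1 1].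

Definition pivots_3 : seq pivot := [::
  (Zmx (-3) (-2) (-1) (-1), Zmx 1 0 0 1, Zmx 0 1 (-1) (-1));
  (Zmx (-3) (-2) 2 1, Zmx 1 1 (-1) 0, Zmx 1 2 (-1) (-1));
  (Zmx (-3) (-1) (-2) (-1), Zmx 1 (-1) 1 0, Zmx (-2) (-1) 1 0);
  (Zmx (-3) (-1) 1 0, Zmx 1 0 0 1, Zmx (-3) (-1) 1 0);
  (Zmx (-3) 1 (-1) 0, Zmx 1 0 0 1, Zmx 0 1 (-1) 0);
  (Zmx (-3) 1 2 (-1), Zmx 1 1 (-1) 0, Zmx 1 1 (-1) 0);
  (Zmx (-3) 2 (-2) 1, Zmx 1 (-1) 1 0, Zmx (-2) 1 1 (-1));
  (Zmx (-3) 2 1 (-1), Zmx 1 0 0 1, Zmx (-3) 2 1 (-1));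
  (Zmx (-2) (-3) (-1) (-2), Zmx 1 (-1) 1 0, Zmx (-1) (-2) 1 1);
  (Zmx (-2) (-3) 1 1, Zmx 1 0 0 1, Zmx (-2) (-3) 1 1);
  (Zmx (-2) 3 (-1) 1, Zmx 1 0 0 1, Zmx 1 0 (-1) 1);
  (Zmx (-2) 3 1 (-2), Zmx 2 1 (-1) 0, Zmx (-1) 2 0 (-1));
  (Zmx (-1) (-3) 0 (-1), Zmx 1 0 0 1, Zmx (-1) 0 0 (-1));
  (Zmx (-1) (-3) 1 2, Zmx 1 1 (-1) 0, Zmx (-1) 1 0 (-1));
  (Zmx (-1) 3 (-1) 2, Zmx 1 (-1) 1 0, Zmx (-1) 2 0 (-1));
  (Zmx (-1) 3 0 (-1), Zmx 1 0 0 1, Zmx (-1) 3 0 (-1));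
  (Zmx 1 (-3) 0 1, Zmx 1 0 0 1, Zmx 1 (-3) 0 1);
  (Zmx 1 (-3) 1 (-2), Zmx 1 0 0 1, Zmx (-2) 3 1 (-2));
  (Zmx 1 3 (-1) (-2), Zmx 1 1 (-1) 0, Zmx 1 (-1) 0 1);
  (Zmx 1 3 0 1, Zmx 1 0 0 1, Zmx 1 0 0 1);
  (Zmx 2 (-3) (-1) 2, Zmx 1 1 (-1) 0, Zmx (-2) 1 1 (-1));
  (Zmx 2 (-3) 1 (-1), Zmx 1 0 0 1, Zmx (-1) 0 1 (-1));
  (Zmx 2 3 (-1) (-1), Zmx 2 1 (-1) 0, Zmx 1 (-2) 0 1);
  (Zmx 2 3 1 2, Zmx 1 0 0 1, Zmx (-1) (-3) 1 2);
  (Zmx 3 (-2) (-1) 1, Zmx 2 1 (-1) 0, Zmx (-2) (-1) 1 0);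
  (Zmx 3 (-2) 2 (-1), Zmx 1 0 0 1, Zmx (-3) 1 2 (-1));
  (Zmx 3 (-1) (-2) 1, Zmx 1 1 (-1) 0, Zmx (-1) (-1) 1 0);
  (Zmx 3 (-1) 1 0, Zmx 1 0 0 1, Zmx 0 (-1) 1 0);
  (Zmx 3 1 (-1) 0, Zmx 1 0 0 1, Zmx 3 1 (-1) 0);
  (Zmx 3 1 2 1, Zmx 1 0 0 1, Zmx (-3) (-2) 2 1);
  (Zmx 3 2 (-2) (-1), Zmx 2 1 (-1) 0, Zmx 2 1 (-1) 0);
  (Zmx 3 2 1 1, Zmx 1 0 0 1, Zmx 0 (-1) 1 1)].

Definition generators_4 : seq zmx := [::
  Zmx (-3) (-2) (-1) (-1); Zmx (-3) (-2) 2 1; Zmx (-3) (-1) (-2) (-1); Zmx (-3) (-1) 1 0;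
  Zmx (-3) 1 (-1) 0; Zmx (-3) 1 2 (-1); Zmx (-3) 2 (-2) 1; Zmx (-3) 2 1 (-1);
  Zmx (-2) (-3) (-1) (-2); Zmx (-2) (-3) 1 1; Zmx (-2) (-1) (-3) (-2); Zmx (-2) (-1) (-1) (-1);
  Zmx (-2) (-1) 1 0; Zmx (-2) (-1) 3 1; Zmx (-2) 1 (-3) 1; Zmx (-2) 1 (-1) 0;
  Zmx (-2) 1 1 (-1); Zmx (-2) 1 3 (-2); Zmx (-2) 3 (-1) 1; Zmx (-2) 3 1 (-2);
  Zmx (-1) (-3) 0 (-1); Zmx (-1) (-3) 1 2; Zmx (-1) (-2) (-1) (-3); Zmx (-1) (-2) 0 (-1);
  Zmx (-1) (-2) 1 1; Zmx (-1) (-2) 2 3; Zmx (-1) (-1) (-2) (-3); Zmx (-1) (-1) (-1) (-2);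
  Zmx (-1) (-1) 0 (-1); Zmx (-1) (-1) 1 0; Zmx (-1) (-1) 2 1; Zmx (-1) (-1) 3 2;
  Zmx (-1) 0 (-3) (-1); Zmx (-1) 0 (-2) (-1); Zmx (-1) 0 (-1) (-1); Zmx (-1) 0 0 (-1);
  Zmx (-1) 0 1 (-1); Zmx (-1) 0 2 (-1); Zmx (-1) 0 3 (-1); Zmx (-1) 1 (-3) 2;
  Zmx (-1) 1 (-2) 1; Zmx (-1) 1 (-1) 0; Zmx (-1) 1 0 (-1); Zmx (-1) 1 1 (-2);
  Zmx (-1) 1 2 (-3); Zmx (-1) 2 (-2) 3; Zmx (-1) 2 (-1) 1; Zmx (-1) 2 0 (-1);
  Zmx (-1) 2 1 (-3); Zmx (-1) 3 (-1) 2; Zmx (-1) 3 0 (-1); Zmx 0 (-1) 1 (-3);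
  Zmx 0 (-1) 1 (-2); Zmx 0 (-1) 1 (-1); Zmx 0 (-1) 1 0; Zmx 0 (-1) 1 1;
  Zmx 0 (-1) 1 2; Zmx 0 (-1) 1 3; Zmx 0 1 (-1) (-3); Zmx 0 1 (-1) (-2);
  Zmx 0 1 (-1) (-1); Zmx 0 1 (-1) 0; Zmx 0 1 (-1) 1; Zmx 0 1 (-1) 2;
  Zmx 0 1 (-1) 3; Zmx 1 (-3) 0 1; Zmx 1 (-3) 1 (-2); Zmx 1 (-2) (-1) 3;
  Zmx 1 (-2) 0 1; Zmx 1 (-2) 1 (-1); Zmx 1 (-2) 2 (-3); Zmx 1 (-1) (-2) 3;
  Zmx 1 (-1) (-1) 2; Zmx 1 (-1) 0 1; Zmx 1 (-1) 1 0; Zmx 1 (-1) 2 (-1);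
  Zmx 1 (-1) 3 (-2); Zmx 1 0 (-3) 1; Zmx 1 0 (-2) 1; Zmx 1 0 (-1) 1;
  Zmx 1 0 0 1; Zmx 1 0 1 1; Zmx 1 0 2 1; Zmx 1 0 3 1;
  Zmx 1 1 (-3) (-2); Zmx 1 1 (-2) (-1); Zmx 1 1 (-1) 0; Zmx 1 1 0 1;
  Zmx 1 1 1 2; Zmx 1 1 2 3; Zmx 1 2 (-2) (-3); Zmx 1 2 (-1) (-1);
  Zmx 1 2 0 1; Zmx 1 2 1 3; Zmx 1 3 (-1) (-2); Zmx 1 3 0 1;
  Zmx 2 (-3) (-1) 2; Zmx 2 (-3) 1 (-1); Zmx 2 (-1) (-3) 2; Zmx 2 (-1) (-1) 1;
  Zmx 2 (-1) 1 0; Zmx 2 (-1) 3 (-1); Zmx 2 1 (-3) (-1); Zmx 2 1 (-1) 0;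
  Zmx 2 1 1 1; Zmx 2 1 3 2; Zmx 2 3 (-1) (-1); Zmx 2 3 1 2;
  Zmx 3 (-2) (-1) 1; Zmx 3 (-2) 2 (-1); Zmx 3 (-1) (-2) 1; Zmx 3 (-1) 1 0;
  Zmx 3 1 (-1) 0; Zmx 3 1 2 1; Zmx 3 2 (-2) (-1); Zmx 3 2 1 1].

Definition pivots_4 : seq pivot := [::
  (Zmx (-5) (-3) 2 1, Zmx 1 0 0 1, Zmx (-5) (-3) 2 1);
  (Zmx (-5) (-2) (-2) (-1), Zmx 1 0 0 1, Zmx 3 2 (-2) (-1));
  (Zmx (-5) (-2) 3 1, Zmx 2 1 (-1) 0, Zmx (-3) (-1) 1 0);
  (Zmx (-5) 2 (-3) 1, Zmx 2 (-1) 1 0, Zmx 1 1 (-1) 0);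
  (Zmx (-5) 2 2 (-1), Zmx 2 1 (-1) 0, Zmx 2 1 (-1) 0);
  (Zmx (-5) 3 (-2) 1, Zmx 1 0 0 1, Zmx 3 (-1) (-2) 1);
  (Zmx (-4) (-3) (-1) (-1), Zmx 1 0 0 1, Zmx 0 1 (-1) (-1));
  (Zmx (-4) (-3) 3 2, Zmx 1 1 (-1) 0, Zmx 1 2 (-1) (-1));
  (Zmx (-4) (-1) (-3) (-1), Zmx 1 (-1) 1 0, Zmx (-3) (-1) 1 0);
  (Zmx (-4) (-1) 1 0, Zmx 1 0 0 1, Zmx (-4) (-1) 1 0);
  (Zmx (-4) 1 (-1) 0, Zmx 1 0 0 1, Zmx 0 1 (-1) 0);
  (Zmx (-4) 1 3 (-1), Zmx 1 1 (-1) 0, Zmx 1 1 (-1) 0);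
  (Zmx (-4) 3 (-3) 2, Zmx 1 (-1) 1 0, Zmx (-3) 2 1 (-1));
  (Zmx (-4) 3 1 (-1), Zmx 1 0 0 1, Zmx (-4) 3 1 (-1));
  (Zmx (-3) (-5) (-1) (-2), Zmx 1 0 0 1, Zmx 1 3 (-1) (-2));
  (Zmx (-3) (-4) (-2) (-3), Zmx 1 (-1) 1 0, Zmx (-2) (-3) 1 1);
  (Zmx (-3) (-4) 1 1, Zmx 1 0 0 1, Zmx (-3) (-4) 1 1);
  (Zmx (-3) (-1) (-5) (-2), Zmx 1 0 2 1, Zmx (-3) (-1) 1 0);
  (Zmx (-3) 4 (-1) 1, Zmx 1 0 0 1, Zmx 1 0 (-1) 1);
  (Zmx (-3) 4 2 (-3), Zmx 1 1 (-1) 0, Zmx 2 (-1) (-1) 1);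
  (Zmx (-3) 5 1 (-2), Zmx 1 0 0 1, Zmx (-3) 5 1 (-2));
  (Zmx (-3) 8 1 (-3), Zmx 3 1 (-1) 0, Zmx (-1) 3 0 (-1));
  (Zmx (-2) (-5) (-1) (-3), Zmx 2 (-1) 1 0, Zmx (-1) 1 0 (-1));
  (Zmx (-2) (-5) 1 2, Zmx 2 1 (-1) 0, Zmx (-1) 2 0 (-1));
  (Zmx (-2) 5 (-1) 2, Zmx 1 0 0 1, Zmx 2 (-3) (-1) 2);
  (Zmx (-2) 5 1 (-3), Zmx 2 1 (-1) 0, Zmx (-1) 3 0 (-1));
  (Zmx (-1) (-4) 0 (-1), Zmx 1 0 0 1, Zmx (-1) 0 0 (-1));
  (Zmx (-1) (-4) 1 3, Zmx 1 1 (-1) 0, Zmx (-1) 1 0 (-1));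
  (Zmx (-1) 3 (-2) 5, Zmx 1 0 2 1, Zmx (-1) 3 0 (-1));
  (Zmx (-1) 4 (-1) 3, Zmx 1 (-1) 1 0, Zmx (-1) 3 0 (-1));
  (Zmx (-1) 4 0 (-1), Zmx 1 0 0 1, Zmx (-1) 4 0 (-1));
  (Zmx 1 (-4) 0 1, Zmx 1 0 0 1, Zmx 1 (-4) 0 1);
  (Zmx 1 (-4) 1 (-3), Zmx 1 0 0 1, Zmx (-3) 8 1 (-3));
  (Zmx 1 4 (-1) (-3), Zmx 1 1 (-1) 0, Zmx 1 (-1) 0 1);
  (Zmx 1 4 0 1, Zmx 1 0 0 1, Zmx 1 0 0 1);
  (Zmx 2 (-5) (-1) 3, Zmx 2 1 (-1) 0, Zmx 1 (-3) 0 1);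
  (Zmx 2 (-5) 1 (-2), Zmx 1 0 0 1, Zmx (-2) 3 1 (-2));
  (Zmx 2 5 (-1) (-2), Zmx 2 1 (-1) 0, Zmx 1 (-2) 0 1);
  (Zmx 2 5 1 3, Zmx 2 (-1) 1 0, Zmx 1 (-1) 0 1);
  (Zmx 3 (-8) (-1) 3, Zmx 1 0 0 1, Zmx 3 (-8) (-1) 3);
  (Zmx 3 (-7) (-2) 5, Zmx 1 1 (-1) 0, Zmx (-2) 3 1 (-2));
  (Zmx 3 (-5) (-1) 2, Zmx 1 0 0 1, Zmx 3 (-5) (-1) 2);
  (Zmx 3 (-5) 2 (-3), Zmx 1 (-1) 1 0, Zmx 2 (-3) (-1) 2);
  (Zmx 3 (-4) (-2) 3, Zmx 1 1 (-1) 0, Zmx (-2) 1 1 (-1));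
  (Zmx 3 (-4) 1 (-1), Zmx 1 0 0 1, Zmx (-1) 0 1 (-1));
  (Zmx 3 4 (-1) (-1), Zmx 3 1 (-1) 0, Zmx 1 (-3) 0 1);
  (Zmx 3 4 2 3, Zmx 1 (-1) 1 0, Zmx 2 3 (-1) (-1));
  (Zmx 3 5 (-2) (-3), Zmx 3 2 (-2) (-1), Zmx 1 (-3) 0 1);
  (Zmx 3 5 1 2, Zmx 1 0 0 1, Zmx (-1) (-3) 1 2);
  (Zmx 4 (-3) (-1) 1, Zmx 1 0 0 1, Zmx 4 (-3) (-1) 1);
  (Zmx 4 (-3) 3 (-2), Zmx 1 (-1) 1 0, Zmx 3 (-2) (-1) 1);
  (Zmx 4 (-1) (-3) 1, Zmx 1 1 (-1) 0, Zmx (-1) (-1) 1 0);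
  (Zmx 4 (-1) 1 0, Zmx 1 0 0 1, Zmx 0 (-1) 1 0);
  (Zmx 4 1 (-1) 0, Zmx 1 0 0 1, Zmx 4 1 (-1) 0);
  (Zmx 4 1 3 1, Zmx 1 (-1) 1 0, Zmx 3 1 (-1) 0);
  (Zmx 4 3 (-3) (-2), Zmx 1 1 (-1) 0, Zmx (-1) (-2) 1 1);
  (Zmx 4 3 1 1, Zmx 1 0 0 1, Zmx 0 (-1) 1 1);
  (Zmx 5 (-7) (-2) 3, Zmx 2 1 (-1) 0, Zmx (-2) 1 1 (-1));
  (Zmx 5 (-3) (-3) 2, Zmx 2 1 (-1) 0, Zmx 3 (-2) (-1) 1);
  (Zmx 5 (-3) 2 (-1), Zmx 1 0 0 1, Zmx (-3) 1 2 (-1));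
  (Zmx 5 (-2) (-2) 1, Zmx 2 1 (-1) 0, Zmx (-2) (-1) 1 0);
  (Zmx 5 (-2) 3 (-1), Zmx 2 (-1) 1 0, Zmx (-1) (-1) 1 0);
  (Zmx 5 2 (-3) (-1), Zmx 2 1 (-1) 0, Zmx 3 1 (-1) 0);
  (Zmx 5 2 2 1, Zmx 1 0 0 1, Zmx (-3) (-2) 2 1);
  (Zmx 5 3 (-2) (-1), Zmx 1 0 0 1, Zmx 5 3 (-2) (-1));
  (Zmx 5 3 3 2, Zmx 1 (-1) 1 0, Zmx 3 2 (-2) (-1));
  (Zmx 7 3 (-5) (-2), Zmx 1 1 (-1) 0, Zmx (-3) (-2) 2 1);
  (Zmx 7 5 (-3) (-2), Zmx 2 1 (-1) 0, Zmx (-1) (-2) 1 1);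
  (Zmx (-5) (-3) (-3) (-2), Zmx 1 0 0 1, Zmx 7 5 (-3) (-2));
  (Zmx (-5) 3 3 (-2), Zmx 3 2 (-2) (-1), Zmx 3 1 (-1) 0);
  (Zmx (-3) (-5) 2 3, Zmx 2 1 (-1) 0, Zmx (-2) (-3) 1 1);
  (Zmx (-3) 5 (-2) 3, Zmx 1 0 0 1, Zmx 5 (-7) (-2) 3)].

Definition generators_5 : seq zmx := [::
  Zmx (-8) (-7) (-1) (-1); Zmx (-8) (-7) 7 6; Zmx (-8) (-5) (-3) (-2); Zmx (-8) (-5) 5 3;
  Zmx (-8) (-3) (-5) (-2); Zmx (-8) (-3) 3 1; Zmx (-8) (-1) (-7) (-1); Zmx (-8) (-1) 1 0;
  Zmx (-8) 1 (-1) 0; Zmx (-8) 1 7 (-1); Zmx (-8) 3 (-3) 1; Zmx (-8) 3 5 (-2);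
  Zmx (-8) 5 (-5) 3; Zmx (-8) 5 3 (-2); Zmx (-8) 7 (-7) 6; Zmx (-8) 7 1 (-1);
  Zmx (-7) (-8) (-6) (-7); Zmx (-7) (-8) 1 1; Zmx (-7) (-6) (-8) (-7); Zmx (-7) (-6) (-1) (-1);
  Zmx (-7) (-6) 6 5; Zmx (-7) (-5) (-4) (-3); Zmx (-7) (-5) 3 2; Zmx (-7) (-4) (-5) (-3);
  Zmx (-7) (-4) 2 1; Zmx (-7) (-3) (-2) (-1); Zmx (-7) (-3) 5 2; Zmx (-7) (-2) (-3) (-1);
  Zmx (-7) (-2) 4 1; Zmx (-7) (-1) (-6) (-1); Zmx (-7) (-1) 1 0; Zmx (-7) (-1) 8 1;
  Zmx (-7) 1 (-8) 1; Zmx (-7) 1 (-1) 0; Zmx (-7) 1 6 (-1); Zmx (-7) 2 (-4) 1;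
  Zmx (-7) 2 3 (-1); Zmx (-7) 3 (-5) 2; Zmx (-7) 3 2 (-1); Zmx (-7) 4 (-2) 1;
  Zmx (-7) 4 5 (-3); Zmx (-7) 5 (-3) 2; Zmx (-7) 5 4 (-3); Zmx (-7) 6 (-6) 5;
  Zmx (-7) 6 1 (-1); Zmx (-7) 6 8 (-7); Zmx (-7) 8 (-1) 1; Zmx (-7) 8 6 (-7);
  Zmx (-6) (-7) (-5) (-6); Zmx (-6) (-7) 1 1; Zmx (-6) (-7) 7 8; Zmx (-6) (-5) (-7) (-6);
  Zmx (-6) (-5) (-1) (-1); Zmx (-6) (-5) 5 4; Zmx (-6) (-1) (-5) (-1); Zmx (-6) (-1) 1 0;
  Zmx (-6) (-1) 7 1; Zmx (-6) 1 (-7) 1; Zmx (-6) 1 (-1) 0; Zmx (-6) 1 5 (-1);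
  Zmx (-6) 5 (-5) 4; Zmx (-6) 5 1 (-1); Zmx (-6) 5 7 (-6); Zmx (-6) 7 (-7) 8;
  Zmx (-6) 7 (-1) 1; Zmx (-6) 7 5 (-6); Zmx (-5) (-8) (-3) (-5); Zmx (-5) (-8) 2 3;
  Zmx (-5) (-7) (-2) (-3); Zmx (-5) (-7) 3 4; Zmx (-5) (-6) (-4) (-5); Zmx (-5) (-6) 1 1;
  Zmx (-5) (-6) 6 7; Zmx (-5) (-4) (-6) (-5); Zmx (-5) (-4) (-1) (-1); Zmx (-5) (-4) 4 3;
  Zmx (-5) (-3) (-8) (-5); Zmx (-5) (-3) (-3) (-2); Zmx (-5) (-3) 2 1; Zmx (-5) (-3) 7 4;
  Zmx (-5) (-2) (-7) (-3); Zmx (-5) (-2) (-2) (-1); Zmx (-5) (-2) 3 1; Zmx (-5) (-2) 8 3;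
  Zmx (-5) (-1) (-4) (-1); Zmx (-5) (-1) 1 0; Zmx (-5) (-1) 6 1; Zmx (-5) 1 (-6) 1;
  Zmx (-5) 1 (-1) 0; Zmx (-5) 1 4 (-1); Zmx (-5) 2 (-8) 3; Zmx (-5) 2 (-3) 1;
  Zmx (-5) 2 2 (-1); Zmx (-5) 2 7 (-3); Zmx (-5) 3 (-7) 4; Zmx (-5) 3 (-2) 1;
  Zmx (-5) 3 3 (-2); Zmx (-5) 3 8 (-5); Zmx (-5) 4 (-4) 3; Zmx (-5) 4 1 (-1);
  Zmx (-5) 4 6 (-5); Zmx (-5) 6 (-6) 7; Zmx (-5) 6 (-1) 1; Zmx (-5) 6 4 (-5);
  Zmx (-5) 7 (-3) 4; Zmx (-5) 7 2 (-3); Zmx (-5) 8 (-2) 3; Zmx (-5) 8 3 (-5);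
  Zmx (-4) (-7) (-1) (-2); Zmx (-4) (-7) 3 5; Zmx (-4) (-5) (-3) (-4); Zmx (-4) (-5) 1 1;
  Zmx (-4) (-5) 5 6; Zmx (-4) (-3) (-5) (-4); Zmx (-4) (-3) (-1) (-1); Zmx (-4) (-3) 3 2;
  Zmx (-4) (-3) 7 5; Zmx (-4) (-1) (-7) (-2); Zmx (-4) (-1) (-3) (-1); Zmx (-4) (-1) 1 0;
  Zmx (-4) (-1) 5 1; Zmx (-4) 1 (-5) 1; Zmx (-4) 1 (-1) 0; Zmx (-4) 1 3 (-1);
  Zmx (-4) 1 7 (-2); Zmx (-4) 3 (-7) 5; Zmx (-4) 3 (-3) 2; Zmx (-4) 3 1 (-1);
  Zmx (-4) 3 5 (-4); Zmx (-4) 5 (-5) 6; Zmx (-4) 5 (-1) 1; Zmx (-4) 5 3 (-4);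
  Zmx (-4) 7 (-3) 5; Zmx (-4) 7 1 (-2); Zmx (-3) (-8) (-1) (-3); Zmx (-3) (-8) 2 5;
  Zmx (-3) (-7) (-2) (-5); Zmx (-3) (-7) 1 2; Zmx (-3) (-5) (-4) (-7); Zmx (-3) (-5) (-1) (-2);
  Zmx (-3) (-5) 2 3; Zmx (-3) (-5) 5 8; Zmx (-3) (-4) (-5) (-7); Zmx (-3) (-4) (-2) (-3);
  Zmx (-3) (-4) 1 1; Zmx (-3) (-4) 4 5; Zmx (-3) (-2) (-7) (-5); Zmx (-3) (-2) (-4) (-3);
  Zmx (-3) (-2) (-1) (-1); Zmx (-3) (-2) 2 1; Zmx (-3) (-2) 5 3; Zmx (-3) (-2) 8 5;
  Zmx (-3) (-1) (-8) (-3); Zmx (-3) (-1) (-5) (-2); Zmx (-3) (-1) (-2) (-1); Zmx (-3) (-1) 1 0;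
  Zmx (-3) (-1) 4 1; Zmx (-3) (-1) 7 2; Zmx (-3) 1 (-7) 2; Zmx (-3) 1 (-4) 1;
  Zmx (-3) 1 (-1) 0; Zmx (-3) 1 2 (-1); Zmx (-3) 1 5 (-2); Zmx (-3) 1 8 (-3);
  Zmx (-3) 2 (-8) 5; Zmx (-3) 2 (-5) 3; Zmx (-3) 2 (-2) 1; Zmx (-3) 2 1 (-1);
  Zmx (-3) 2 4 (-3); Zmx (-3) 2 7 (-5); Zmx (-3) 4 (-4) 5; Zmx (-3) 4 (-1) 1;
  Zmx (-3) 4 2 (-3); Zmx (-3) 4 5 (-7); Zmx (-3) 5 (-5) 8; Zmx (-3) 5 (-2) 3;
  Zmx (-3) 5 1 (-2); Zmx (-3) 5 4 (-7); Zmx (-3) 7 (-1) 2; Zmx (-3) 7 2 (-5);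
  Zmx (-3) 8 (-2) 5; Zmx (-3) 8 1 (-3); Zmx (-2) (-7) (-1) (-4); Zmx (-2) (-7) 1 3;
  Zmx (-2) (-5) (-3) (-8); Zmx (-2) (-5) (-1) (-3); Zmx (-2) (-5) 1 2; Zmx (-2) (-5) 3 7;
  Zmx (-2) (-3) (-5) (-8); Zmx (-2) (-3) (-3) (-5); Zmx (-2) (-3) (-1) (-2); Zmx (-2) (-3) 1 1;
  Zmx (-2) (-3) 3 4; Zmx (-2) (-3) 5 7; Zmx (-2) (-1) (-7) (-4); Zmx (-2) (-1) (-5) (-3);
  Zmx (-2) (-1) (-3) (-2); Zmx (-2) (-1) (-1) (-1); Zmx (-2) (-1) 1 0; Zmx (-2) (-1) 3 1;
  Zmx (-2) (-1) 5 2; Zmx (-2) (-1) 7 3; Zmx (-2) 1 (-7) 3; Zmx (-2) 1 (-5) 2;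
  Zmx (-2) 1 (-3) 1; Zmx (-2) 1 (-1) 0; Zmx (-2) 1 1 (-1); Zmx (-2) 1 3 (-2);
  Zmx (-2) 1 5 (-3); Zmx (-2) 1 7 (-4); Zmx (-2) 3 (-5) 7; Zmx (-2) 3 (-3) 4;
  Zmx (-2) 3 (-1) 1; Zmx (-2) 3 1 (-2); Zmx (-2) 3 3 (-5); Zmx (-2) 3 5 (-8);
  Zmx (-2) 5 (-3) 7; Zmx (-2) 5 (-1) 2; Zmx (-2) 5 1 (-3); Zmx (-2) 5 3 (-8);
  Zmx (-2) 7 (-1) 3; Zmx (-2) 7 1 (-4); Zmx (-1) (-8) 0 (-1); Zmx (-1) (-8) 1 7;
  Zmx (-1) (-7) (-1) (-8); Zmx (-1) (-7) 0 (-1); Zmx (-1) (-7) 1 6; Zmx (-1) (-6) (-1) (-7);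
  Zmx (-1) (-6) 0 (-1); Zmx (-1) (-6) 1 5; Zmx (-1) (-5) (-1) (-6); Zmx (-1) (-5) 0 (-1);
  Zmx (-1) (-5) 1 4; Zmx (-1) (-4) (-1) (-5); Zmx (-1) (-4) 0 (-1); Zmx (-1) (-4) 1 3;
  Zmx (-1) (-4) 2 7; Zmx (-1) (-3) (-2) (-7); Zmx (-1) (-3) (-1) (-4); Zmx (-1) (-3) 0 (-1);
  Zmx (-1) (-3) 1 2; Zmx (-1) (-3) 2 5; Zmx (-1) (-3) 3 8; Zmx (-1) (-2) (-3) (-7);
  Zmx (-1) (-2) (-2) (-5); Zmx (-1) (-2) (-1) (-3); Zmx (-1) (-2) 0 (-1); Zmx (-1) (-2) 1 1;
  Zmx (-1) (-2) 2 3; Zmx (-1) (-2) 3 5; Zmx (-1) (-2) 4 7; Zmx (-1) (-1) (-7) (-8);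
  Zmx (-1) (-1) (-6) (-7); Zmx (-1) (-1) (-5) (-6); Zmx (-1) (-1) (-4) (-5); Zmx (-1) (-1) (-3) (-4);
  Zmx (-1) (-1) (-2) (-3); Zmx (-1) (-1) (-1) (-2); Zmx (-1) (-1) 0 (-1); Zmx (-1) (-1) 1 0;
  Zmx (-1) (-1) 2 1; Zmx (-1) (-1) 3 2; Zmx (-1) (-1) 4 3; Zmx (-1) (-1) 5 4;
  Zmx (-1) (-1) 6 5; Zmx (-1) (-1) 7 6; Zmx (-1) (-1) 8 7; Zmx (-1) 0 (-8) (-1);
  Zmx (-1) 0 (-7) (-1); Zmx (-1) 0 (-6) (-1); Zmx (-1) 0 (-5) (-1); Zmx (-1) 0 (-4) (-1);
  Zmx (-1) 0 (-3) (-1); Zmx (-1) 0 (-2) (-1); Zmx (-1) 0 (-1) (-1); Zmx (-1) 0 0 (-1);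
  Zmx (-1) 0 1 (-1); Zmx (-1) 0 2 (-1); Zmx (-1) 0 3 (-1); Zmx (-1) 0 4 (-1);
  Zmx (-1) 0 5 (-1); Zmx (-1) 0 6 (-1); Zmx (-1) 0 7 (-1); Zmx (-1) 0 8 (-1);
  Zmx (-1) 1 (-8) 7; Zmx (-1) 1 (-7) 6; Zmx (-1) 1 (-6) 5; Zmx (-1) 1 (-5) 4;
  Zmx (-1) 1 (-4) 3; Zmx (-1) 1 (-3) 2; Zmx (-1) 1 (-2) 1; Zmx (-1) 1 (-1) 0;
  Zmx (-1) 1 0 (-1); Zmx (-1) 1 1 (-2); Zmx (-1) 1 2 (-3); Zmx (-1) 1 3 (-4);
  Zmx (-1) 1 4 (-5); Zmx (-1) 1 5 (-6); Zmx (-1) 1 6 (-7); Zmx (-1) 1 7 (-8);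
  Zmx (-1) 2 (-4) 7; Zmx (-1) 2 (-3) 5; Zmx (-1) 2 (-2) 3; Zmx (-1) 2 (-1) 1;
  Zmx (-1) 2 0 (-1); Zmx (-1) 2 1 (-3); Zmx (-1) 2 2 (-5); Zmx (-1) 2 3 (-7);
  Zmx (-1) 3 (-3) 8; Zmx (-1) 3 (-2) 5; Zmx (-1) 3 (-1) 2; Zmx (-1) 3 0 (-1);
  Zmx (-1) 3 1 (-4); Zmx (-1) 3 2 (-7); Zmx (-1) 4 (-2) 7; Zmx (-1) 4 (-1) 3;
  Zmx (-1) 4 0 (-1); Zmx (-1) 4 1 (-5); Zmx (-1) 5 (-1) 4; Zmx (-1) 5 0 (-1);
  Zmx (-1) 5 1 (-6); Zmx (-1) 6 (-1) 5; Zmx (-1) 6 0 (-1); Zmx (-1) 6 1 (-7);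
  Zmx (-1) 7 (-1) 6; Zmx (-1) 7 0 (-1); Zmx (-1) 7 1 (-8); Zmx (-1) 8 (-1) 7;
  Zmx (-1) 8 0 (-1); Zmx 0 (-1) 1 (-8); Zmx 0 (-1) 1 (-7); Zmx 0 (-1) 1 (-6);
  Zmx 0 (-1) 1 (-5); Zmx 0 (-1) 1 (-4); Zmx 0 (-1) 1 (-3); Zmx 0 (-1) 1 (-2);
  Zmx 0 (-1) 1 (-1); Zmx 0 (-1) 1 0; Zmx 0 (-1) 1 1; Zmx 0 (-1) 1 2;
  Zmx 0 (-1) 1 3; Zmx 0 (-1) 1 4; Zmx 0 (-1) 1 5; Zmx 0 (-1) 1 6;
  Zmx 0 (-1) 1 7; Zmx 0 (-1) 1 8; Zmx 0 1 (-1) (-8); Zmx 0 1 (-1) (-7);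
  Zmx 0 1 (-1) (-6); Zmx 0 1 (-1) (-5); Zmx 0 1 (-1) (-4); Zmx 0 1 (-1) (-3);
  Zmx 0 1 (-1) (-2); Zmx 0 1 (-1) (-1); Zmx 0 1 (-1) 0; Zmx 0 1 (-1) 1;
  Zmx 0 1 (-1) 2; Zmx 0 1 (-1) 3; Zmx 0 1 (-1) 4; Zmx 0 1 (-1) 5;
  Zmx 0 1 (-1) 6; Zmx 0 1 (-1) 7; Zmx 0 1 (-1) 8; Zmx 1 (-8) 0 1;
  Zmx 1 (-8) 1 (-7); Zmx 1 (-7) (-1) 8; Zmx 1 (-7) 0 1; Zmx 1 (-7) 1 (-6);
  Zmx 1 (-6) (-1) 7; Zmx 1 (-6) 0 1; Zmx 1 (-6) 1 (-5); Zmx 1 (-5) (-1) 6;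
  Zmx 1 (-5) 0 1; Zmx 1 (-5) 1 (-4); Zmx 1 (-4) (-1) 5; Zmx 1 (-4) 0 1;
  Zmx 1 (-4) 1 (-3); Zmx 1 (-4) 2 (-7); Zmx 1 (-3) (-2) 7; Zmx 1 (-3) (-1) 4;
  Zmx 1 (-3) 0 1; Zmx 1 (-3) 1 (-2); Zmx 1 (-3) 2 (-5); Zmx 1 (-3) 3 (-8);
  Zmx 1 (-2) (-3) 7; Zmx 1 (-2) (-2) 5; Zmx 1 (-2) (-1) 3; Zmx 1 (-2) 0 1;
  Zmx 1 (-2) 1 (-1); Zmx 1 (-2) 2 (-3); Zmx 1 (-2) 3 (-5); Zmx 1 (-2) 4 (-7);
  Zmx 1 (-1) (-7) 8; Zmx 1 (-1) (-6) 7; Zmx 1 (-1) (-5) 6; Zmx 1 (-1) (-4) 5;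
  Zmx 1 (-1) (-3) 4; Zmx 1 (-1) (-2) 3; Zmx 1 (-1) (-1) 2; Zmx 1 (-1) 0 1;
  Zmx 1 (-1) 1 0; Zmx 1 (-1) 2 (-1); Zmx 1 (-1) 3 (-2); Zmx 1 (-1) 4 (-3);
  Zmx 1 (-1) 5 (-4); Zmx 1 (-1) 6 (-5); Zmx 1 (-1) 7 (-6); Zmx 1 (-1) 8 (-7);
  Zmx 1 0 (-8) 1; Zmx 1 0 (-7) 1; Zmx 1 0 (-6) 1; Zmx 1 0 (-5) 1;
  Zmx 1 0 (-4) 1; Zmx 1 0 (-3) 1; Zmx 1 0 (-2) 1; Zmx 1 0 (-1) 1;
  Zmx 1 0 0 1; Zmx 1 0 1 1; Zmx 1 0 2 1; Zmx 1 0 3 1;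
  Zmx 1 0 4 1; Zmx 1 0 5 1; Zmx 1 0 6 1; Zmx 1 0 7 1;
  Zmx 1 0 8 1; Zmx 1 1 (-8) (-7); Zmx 1 1 (-7) (-6); Zmx 1 1 (-6) (-5);
  Zmx 1 1 (-5) (-4); Zmx 1 1 (-4) (-3); Zmx 1 1 (-3) (-2); Zmx 1 1 (-2) (-1);
  Zmx 1 1 (-1) 0; Zmx 1 1 0 1; Zmx 1 1 1 2; Zmx 1 1 2 3;
  Zmx 1 1 3 4; Zmx 1 1 4 5; Zmx 1 1 5 6; Zmx 1 1 6 7;
  Zmx 1 1 7 8; Zmx 1 2 (-4) (-7); Zmx 1 2 (-3) (-5); Zmx 1 2 (-2) (-3);
  Zmx 1 2 (-1) (-1); Zmx 1 2 0 1; Zmx 1 2 1 3; Zmx 1 2 2 5;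
  Zmx 1 2 3 7; Zmx 1 3 (-3) (-8); Zmx 1 3 (-2) (-5); Zmx 1 3 (-1) (-2);
  Zmx 1 3 0 1; Zmx 1 3 1 4; Zmx 1 3 2 7; Zmx 1 4 (-2) (-7);
  Zmx 1 4 (-1) (-3); Zmx 1 4 0 1; Zmx 1 4 1 5; Zmx 1 5 (-1) (-4);
  Zmx 1 5 0 1; Zmx 1 5 1 6; Zmx 1 6 (-1) (-5); Zmx 1 6 0 1;
  Zmx 1 6 1 7; Zmx 1 7 (-1) (-6); Zmx 1 7 0 1; Zmx 1 7 1 8;
  Zmx 1 8 (-1) (-7); Zmx 1 8 0 1; Zmx 2 (-7) (-1) 4; Zmx 2 (-7) 1 (-3);
  Zmx 2 (-5) (-3) 8; Zmx 2 (-5) (-1) 3; Zmx 2 (-5) 1 (-2); Zmx 2 (-5) 3 (-7);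
  Zmx 2 (-3) (-5) 8; Zmx 2 (-3) (-3) 5; Zmx 2 (-3) (-1) 2; Zmx 2 (-3) 1 (-1);
  Zmx 2 (-3) 3 (-4); Zmx 2 (-3) 5 (-7); Zmx 2 (-1) (-7) 4; Zmx 2 (-1) (-5) 3;
  Zmx 2 (-1) (-3) 2; Zmx 2 (-1) (-1) 1; Zmx 2 (-1) 1 0; Zmx 2 (-1) 3 (-1);
  Zmx 2 (-1) 5 (-2); Zmx 2 (-1) 7 (-3); Zmx 2 1 (-7) (-3); Zmx 2 1 (-5) (-2);
  Zmx 2 1 (-3) (-1); Zmx 2 1 (-1) 0; Zmx 2 1 1 1; Zmx 2 1 3 2;
  Zmx 2 1 5 3; Zmx 2 1 7 4; Zmx 2 3 (-5) (-7); Zmx 2 3 (-3) (-4);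
  Zmx 2 3 (-1) (-1); Zmx 2 3 1 2; Zmx 2 3 3 5; Zmx 2 3 5 8;
  Zmx 2 5 (-3) (-7); Zmx 2 5 (-1) (-2); Zmx 2 5 1 3; Zmx 2 5 3 8;
  Zmx 2 7 (-1) (-3); Zmx 2 7 1 4; Zmx 3 (-8) (-1) 3; Zmx 3 (-8) 2 (-5);
  Zmx 3 (-7) (-2) 5; Zmx 3 (-7) 1 (-2); Zmx 3 (-5) (-4) 7; Zmx 3 (-5) (-1) 2;
  Zmx 3 (-5) 2 (-3); Zmx 3 (-5) 5 (-8); Zmx 3 (-4) (-5) 7; Zmx 3 (-4) (-2) 3;
  Zmx 3 (-4) 1 (-1); Zmx 3 (-4) 4 (-5); Zmx 3 (-2) (-7) 5; Zmx 3 (-2) (-4) 3;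
  Zmx 3 (-2) (-1) 1; Zmx 3 (-2) 2 (-1); Zmx 3 (-2) 5 (-3); Zmx 3 (-2) 8 (-5);
  Zmx 3 (-1) (-8) 3; Zmx 3 (-1) (-5) 2; Zmx 3 (-1) (-2) 1; Zmx 3 (-1) 1 0;
  Zmx 3 (-1) 4 (-1); Zmx 3 (-1) 7 (-2); Zmx 3 1 (-7) (-2); Zmx 3 1 (-4) (-1);
  Zmx 3 1 (-1) 0; Zmx 3 1 2 1; Zmx 3 1 5 2; Zmx 3 1 8 3;
  Zmx 3 2 (-8) (-5); Zmx 3 2 (-5) (-3); Zmx 3 2 (-2) (-1); Zmx 3 2 1 1;
  Zmx 3 2 4 3; Zmx 3 2 7 5; Zmx 3 4 (-4) (-5); Zmx 3 4 (-1) (-1);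
  Zmx 3 4 2 3; Zmx 3 4 5 7; Zmx 3 5 (-5) (-8); Zmx 3 5 (-2) (-3);
  Zmx 3 5 1 2; Zmx 3 5 4 7; Zmx 3 7 (-1) (-2); Zmx 3 7 2 5;
  Zmx 3 8 (-2) (-5); Zmx 3 8 1 3; Zmx 4 (-7) (-1) 2; Zmx 4 (-7) 3 (-5);
  Zmx 4 (-5) (-3) 4; Zmx 4 (-5) 1 (-1); Zmx 4 (-5) 5 (-6); Zmx 4 (-3) (-5) 4;
  Zmx 4 (-3) (-1) 1; Zmx 4 (-3) 3 (-2); Zmx 4 (-3) 7 (-5); Zmx 4 (-1) (-7) 2;
  Zmx 4 (-1) (-3) 1; Zmx 4 (-1) 1 0; Zmx 4 (-1) 5 (-1); Zmx 4 1 (-5) (-1);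
  Zmx 4 1 (-1) 0; Zmx 4 1 3 1; Zmx 4 1 7 2; Zmx 4 3 (-7) (-5);
  Zmx 4 3 (-3) (-2); Zmx 4 3 1 1; Zmx 4 3 5 4; Zmx 4 5 (-5) (-6);
  Zmx 4 5 (-1) (-1); Zmx 4 5 3 4; Zmx 4 7 (-3) (-5); Zmx 4 7 1 2;
  Zmx 5 (-8) (-3) 5; Zmx 5 (-8) 2 (-3); Zmx 5 (-7) (-2) 3; Zmx 5 (-7) 3 (-4);
  Zmx 5 (-6) (-4) 5; Zmx 5 (-6) 1 (-1); Zmx 5 (-6) 6 (-7); Zmx 5 (-4) (-6) 5;
  Zmx 5 (-4) (-1) 1; Zmx 5 (-4) 4 (-3); Zmx 5 (-3) (-8) 5; Zmx 5 (-3) (-3) 2;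
  Zmx 5 (-3) 2 (-1); Zmx 5 (-3) 7 (-4); Zmx 5 (-2) (-7) 3; Zmx 5 (-2) (-2) 1;
  Zmx 5 (-2) 3 (-1); Zmx 5 (-2) 8 (-3); Zmx 5 (-1) (-4) 1; Zmx 5 (-1) 1 0;
  Zmx 5 (-1) 6 (-1); Zmx 5 1 (-6) (-1); Zmx 5 1 (-1) 0; Zmx 5 1 4 1;
  Zmx 5 2 (-8) (-3); Zmx 5 2 (-3) (-1); Zmx 5 2 2 1; Zmx 5 2 7 3;
  Zmx 5 3 (-7) (-4); Zmx 5 3 (-2) (-1); Zmx 5 3 3 2; Zmx 5 3 8 5;
  Zmx 5 4 (-4) (-3); Zmx 5 4 1 1; Zmx 5 4 6 5; Zmx 5 6 (-6) (-7);
  Zmx 5 6 (-1) (-1); Zmx 5 6 4 5; Zmx 5 7 (-3) (-4); Zmx 5 7 2 3;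
  Zmx 5 8 (-2) (-3); Zmx 5 8 3 5; Zmx 6 (-7) (-5) 6; Zmx 6 (-7) 1 (-1);
  Zmx 6 (-7) 7 (-8); Zmx 6 (-5) (-7) 6; Zmx 6 (-5) (-1) 1; Zmx 6 (-5) 5 (-4);
  Zmx 6 (-1) (-5) 1; Zmx 6 (-1) 1 0; Zmx 6 (-1) 7 (-1); Zmx 6 1 (-7) (-1);
  Zmx 6 1 (-1) 0; Zmx 6 1 5 1; Zmx 6 5 (-5) (-4); Zmx 6 5 1 1;
  Zmx 6 5 7 6; Zmx 6 7 (-7) (-8); Zmx 6 7 (-1) (-1); Zmx 6 7 5 6;
  Zmx 7 (-8) (-6) 7; Zmx 7 (-8) 1 (-1); Zmx 7 (-6) (-8) 7; Zmx 7 (-6) (-1) 1;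
  Zmx 7 (-6) 6 (-5); Zmx 7 (-5) (-4) 3; Zmx 7 (-5) 3 (-2); Zmx 7 (-4) (-5) 3;
  Zmx 7 (-4) 2 (-1); Zmx 7 (-3) (-2) 1; Zmx 7 (-3) 5 (-2); Zmx 7 (-2) (-3) 1;
  Zmx 7 (-2) 4 (-1); Zmx 7 (-1) (-6) 1; Zmx 7 (-1) 1 0; Zmx 7 (-1) 8 (-1);
  Zmx 7 1 (-8) (-1); Zmx 7 1 (-1) 0; Zmx 7 1 6 1; Zmx 7 2 (-4) (-1);
  Zmx 7 2 3 1; Zmx 7 3 (-5) (-2); Zmx 7 3 2 1; Zmx 7 4 (-2) (-1);
  Zmx 7 4 5 3; Zmx 7 5 (-3) (-2); Zmx 7 5 4 3; Zmx 7 6 (-6) (-5);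
  Zmx 7 6 1 1; Zmx 7 6 8 7; Zmx 7 8 (-1) (-1); Zmx 7 8 6 7;
  Zmx 8 (-7) (-1) 1; Zmx 8 (-7) 7 (-6); Zmx 8 (-5) (-3) 2; Zmx 8 (-5) 5 (-3);
  Zmx 8 (-3) (-5) 2; Zmx 8 (-3) 3 (-1); Zmx 8 (-1) (-7) 1; Zmx 8 (-1) 1 0;
  Zmx 8 1 (-1) 0; Zmx 8 1 7 1; Zmx 8 3 (-3) (-1); Zmx 8 3 5 2;
  Zmx 8 5 (-5) (-3); Zmx 8 5 3 2; Zmx 8 7 (-7) (-6); Zmx 8 7 1 1].

Definition pivots_5 : seq pivot := [::
  (Zmx (-12) (-7) (-5) (-3), Zmx 2 (-1) 1 0, Zmx (-5) (-3) 2 1);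
  (Zmx (-12) (-7) 7 4, Zmx 2 1 (-1) 0, Zmx (-7) (-4) 2 1);
  (Zmx (-12) (-5) (-7) (-3), Zmx 2 (-1) 1 0, Zmx 3 2 (-2) (-1));
  (Zmx (-12) (-5) 5 2, Zmx 2 1 (-1) 0, Zmx 5 3 (-2) (-1));
  (Zmx (-12) 5 (-5) 2, Zmx 2 (-1) 1 0, Zmx (-5) 2 2 (-1));
  (Zmx (-12) 5 7 (-3), Zmx 2 1 (-1) 0, Zmx (-7) 3 2 (-1));
  (Zmx (-12) 7 (-7) 4, Zmx 2 (-1) 1 0, Zmx 3 (-1) (-2) 1);
  (Zmx (-12) 7 5 (-3), Zmx 2 1 (-1) 0, Zmx 5 (-2) (-2) 1);
  (Zmx (-11) (-8) (-4) (-3), Zmx 3 (-1) 1 0, Zmx 1 2 (-1) (-1));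
  (Zmx (-11) (-8) 7 5, Zmx 3 2 (-2) (-1), Zmx 2 3 (-1) (-1));
  (Zmx (-11) (-7) (-3) (-2), Zmx 1 0 0 1, Zmx 4 3 (-3) (-2));
  (Zmx (-11) (-7) 8 5, Zmx 1 1 (-1) 0, Zmx 7 5 (-3) (-2));
  (Zmx (-11) (-4) (-8) (-3), Zmx 1 (-1) 1 0, Zmx (-8) (-3) 3 1);
  (Zmx (-11) (-4) 3 1, Zmx 1 0 0 1, Zmx (-11) (-4) 3 1);
  (Zmx (-11) (-3) (-7) (-2), Zmx 3 1 2 1, Zmx (-4) (-1) 1 0);
  (Zmx (-11) (-3) 4 1, Zmx 3 1 (-1) 0, Zmx (-4) (-1) 1 0);
  (Zmx (-11) 3 (-4) 1, Zmx 3 (-1) 1 0, Zmx 1 1 (-1) 0);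
  (Zmx (-11) 3 7 (-2), Zmx 3 2 (-2) (-1), Zmx 2 1 (-1) 0);
  (Zmx (-11) 4 (-3) 1, Zmx 1 0 0 1, Zmx 4 (-1) (-3) 1);
  (Zmx (-11) 4 8 (-3), Zmx 1 1 (-1) 0, Zmx 7 (-2) (-3) 1);
  (Zmx (-11) 7 (-8) 5, Zmx 1 (-1) 1 0, Zmx (-8) 5 3 (-2));
  (Zmx (-11) 7 3 (-2), Zmx 1 0 0 1, Zmx (-11) 7 3 (-2));
  (Zmx (-11) 8 (-7) 5, Zmx 3 1 2 1, Zmx (-4) 3 1 (-1));
  (Zmx (-11) 8 4 (-3), Zmx 3 1 (-1) 0, Zmx (-4) 3 1 (-1));
  (Zmx (-10) (-7) (-7) (-5), Zmx 1 (-1) 1 0, Zmx (-7) (-5) 3 2);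
  (Zmx (-10) (-7) 3 2, Zmx 3 1 (-1) 0, Zmx 2 3 (-1) (-1));
  (Zmx (-10) (-3) (-3) (-1), Zmx 1 0 0 1, Zmx 5 2 (-3) (-1));
  (Zmx (-10) (-3) 7 2, Zmx 3 2 (-2) (-1), Zmx (-4) (-1) 1 0);
  (Zmx (-10) 3 (-7) 2, Zmx 1 (-1) 1 0, Zmx (-7) 2 3 (-1));
  (Zmx (-10) 3 3 (-1), Zmx 3 1 (-1) 0, Zmx 2 1 (-1) 0);
  (Zmx (-10) 7 (-3) 2, Zmx 1 0 0 1, Zmx 5 (-3) (-3) 2);
  (Zmx (-10) 7 7 (-5), Zmx 3 2 (-2) (-1), Zmx (-4) 3 1 (-1));
  (Zmx (-9) (-8) (-1) (-1), Zmx 1 0 0 1, Zmx (-4) (-3) (-1) (-1));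
  (Zmx (-9) (-8) 8 7, Zmx 1 1 (-1) 0, Zmx (-3) (-2) (-1) (-1));
  (Zmx (-9) (-7) (-5) (-4), Zmx 2 (-1) 1 0, Zmx 0 1 (-1) (-1));
  (Zmx (-9) (-7) 4 3, Zmx 2 1 (-1) 0, Zmx 1 2 (-1) (-1));
  (Zmx (-9) (-5) (-7) (-4), Zmx 1 (-1) 1 0, Zmx (-7) (-4) 2 1);
  (Zmx (-9) (-5) 2 1, Zmx 1 0 0 1, Zmx (-9) (-5) 2 1);
  (Zmx (-9) (-4) (-2) (-1), Zmx 1 0 0 1, Zmx 1 1 (-2) (-1));
  (Zmx (-9) (-4) 7 3, Zmx 1 1 (-1) 0, Zmx 3 2 (-2) (-1));
  (Zmx (-9) (-2) (-4) (-1), Zmx 2 (-1) 1 0, Zmx (-4) (-1) 1 0);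
  (Zmx (-9) (-2) 5 1, Zmx 2 1 (-1) 0, Zmx (-5) (-1) 1 0);
  (Zmx (-9) (-1) (-8) (-1), Zmx 1 (-1) 1 0, Zmx (-8) (-1) 1 0);
  (Zmx (-9) (-1) 1 0, Zmx 1 0 0 1, Zmx (-9) (-1) 1 0);
  (Zmx (-9) 1 (-1) 0, Zmx 1 0 0 1, Zmx (-4) 1 (-1) 0);
  (Zmx (-9) 1 8 (-1), Zmx 1 1 (-1) 0, Zmx (-3) 1 (-1) 0);
  (Zmx (-9) 2 (-5) 1, Zmx 2 (-1) 1 0, Zmx 0 1 (-1) 0);
  (Zmx (-9) 2 4 (-1), Zmx 2 1 (-1) 0, Zmx 1 1 (-1) 0);
  (Zmx (-9) 4 (-7) 3, Zmx 1 (-1) 1 0, Zmx (-7) 3 2 (-1));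
  (Zmx (-9) 4 2 (-1), Zmx 1 0 0 1, Zmx (-9) 4 2 (-1));
  (Zmx (-9) 5 (-2) 1, Zmx 1 0 0 1, Zmx 1 0 (-2) 1);
  (Zmx (-9) 5 7 (-4), Zmx 1 1 (-1) 0, Zmx 3 (-1) (-2) 1);
  (Zmx (-9) 7 (-4) 3, Zmx 2 (-1) 1 0, Zmx (-4) 3 1 (-1));
  (Zmx (-9) 7 5 (-4), Zmx 2 1 (-1) 0, Zmx (-5) 4 1 (-1));
  (Zmx (-9) 8 (-8) 7, Zmx 1 (-1) 1 0, Zmx (-8) 7 1 (-1));
  (Zmx (-9) 8 1 (-1), Zmx 1 0 0 1, Zmx (-9) 8 1 (-1));
  (Zmx (-8) (-11) (-5) (-7), Zmx 3 1 2 1, Zmx (-3) (-4) 1 1);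
  (Zmx (-8) (-11) 3 4, Zmx 3 1 (-1) 0, Zmx (-3) (-4) 1 1);
  (Zmx (-8) (-9) (-7) (-8), Zmx 1 (-1) 1 0, Zmx (-7) (-8) 1 1);
  (Zmx (-8) (-9) 1 1, Zmx 1 0 0 1, Zmx (-8) (-9) 1 1);
  (Zmx (-8) (-5) (-11) (-7), Zmx 1 (-1) 1 0, Zmx 4 3 (-3) (-2));
  (Zmx (-8) (-3) 11 4, Zmx 1 1 (-1) 0, Zmx (-11) (-4) 3 1);
  (Zmx (-8) 5 11 (-7), Zmx 1 1 (-1) 0, Zmx (-11) 7 3 (-2));
  (Zmx (-8) 9 (-1) 1, Zmx 1 0 0 1, Zmx (-3) 4 (-1) 1);
  (Zmx (-8) 9 7 (-8), Zmx 1 1 (-1) 0, Zmx (-2) 3 (-1) 1);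
  (Zmx (-8) 11 (-3) 4, Zmx 3 (-1) 1 0, Zmx 2 (-1) (-1) 1);
  (Zmx (-8) 11 5 (-7), Zmx 3 2 (-2) (-1), Zmx 3 (-2) (-1) 1);
  (Zmx (-7) (-12) (-4) (-7), Zmx 2 (-1) 1 0, Zmx 1 3 (-1) (-2));
  (Zmx (-7) (-12) 3 5, Zmx 2 1 (-1) 0, Zmx 2 5 (-1) (-2));
  (Zmx (-7) (-11) (-5) (-8), Zmx 1 (-1) 1 0, Zmx (-5) (-8) 2 3);
  (Zmx (-7) (-11) 2 3, Zmx 1 0 0 1, Zmx (-7) (-11) 2 3);
  (Zmx (-7) (-10) (-2) (-3), Zmx 1 0 0 1, Zmx 3 5 (-2) (-3));
  (Zmx (-7) (-10) 5 7, Zmx 3 2 (-2) (-1), Zmx (-3) (-4) 1 1);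
  (Zmx (-7) (-9) (-3) (-4), Zmx 2 (-1) 1 0, Zmx (-3) (-4) 1 1);
  (Zmx (-7) (-9) 4 5, Zmx 2 1 (-1) 0, Zmx (-4) (-5) 1 1);
  (Zmx (-7) (-4) (-12) (-7), Zmx 1 0 2 1, Zmx (-7) (-4) 2 1);
  (Zmx (-7) (-4) 9 5, Zmx 1 1 (-1) 0, Zmx (-9) (-5) 2 1);
  (Zmx (-7) 3 (-12) 5, Zmx 1 0 2 1, Zmx (-7) 3 2 (-1));
  (Zmx (-7) 3 9 (-4), Zmx 1 1 (-1) 0, Zmx (-9) 4 2 (-1));
  (Zmx (-7) 9 (-4) 5, Zmx 2 (-1) 1 0, Zmx 1 0 (-1) 1);
  (Zmx (-7) 9 3 (-4), Zmx 2 1 (-1) 0, Zmx 2 (-1) (-1) 1);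
  (Zmx (-7) 10 (-5) 7, Zmx 1 (-1) 1 0, Zmx (-5) 7 2 (-3));
  (Zmx (-7) 10 2 (-3), Zmx 3 1 (-1) 0, Zmx 3 (-2) (-1) 1);
  (Zmx (-7) 11 (-2) 3, Zmx 1 0 0 1, Zmx 3 (-4) (-2) 3);
  (Zmx (-7) 11 5 (-8), Zmx 1 1 (-1) 0, Zmx 5 (-7) (-2) 3);
  (Zmx (-7) 12 (-3) 5, Zmx 2 (-1) 1 0, Zmx (-3) 5 1 (-2));
  (Zmx (-7) 12 4 (-7), Zmx 2 1 (-1) 0, Zmx (-4) 7 1 (-2));
  (Zmx (-5) (-12) (-2) (-5), Zmx 2 (-1) 1 0, Zmx (-2) (-5) 1 2);
  (Zmx (-5) (-12) 3 7, Zmx 2 1 (-1) 0, Zmx (-3) (-7) 1 2);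
  (Zmx (-5) (-9) (-1) (-2), Zmx 1 0 0 1, Zmx 0 1 (-1) (-2));
  (Zmx (-5) (-9) 4 7, Zmx 1 1 (-1) 0, Zmx 1 3 (-1) (-2));
  (Zmx (-5) (-8) 7 11, Zmx 1 1 (-1) 0, Zmx (-7) (-11) 2 3);
  (Zmx (-5) (-2) (-12) (-5), Zmx 1 0 2 1, Zmx 5 3 (-2) (-1));
  (Zmx (-5) (-2) 13 5, Zmx 0 (-1) 1 0, Zmx (-12) (-5) 5 2);
  (Zmx (-5) (-2) 18 7, Zmx 0 (-1) 1 0, Zmx (-7) (-3) 5 2);
  (Zmx (-5) (-2) 23 9, Zmx 0 (-1) 1 0, Zmx (-2) (-1) 5 2);
  (Zmx (-5) 2 12 (-5), Zmx 1 1 (-2) (-1), Zmx (-7) 3 2 (-1));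
  (Zmx (-5) 2 17 (-7), Zmx 0 (-1) 1 0, Zmx (-8) 3 5 (-2));
  (Zmx (-5) 8 (-7) 11, Zmx 1 (-1) 1 0, Zmx 3 (-4) (-2) 3);
  (Zmx (-5) 9 (-4) 7, Zmx 1 (-1) 1 0, Zmx (-4) 7 1 (-2));
  (Zmx (-5) 9 1 (-2), Zmx 1 0 0 1, Zmx (-5) 9 1 (-2));
  (Zmx (-5) 12 (-3) 7, Zmx 2 (-1) 1 0, Zmx 2 (-3) (-1) 2);
  (Zmx (-5) 12 2 (-5), Zmx 2 1 (-1) 0, Zmx 3 (-5) (-1) 2);
  (Zmx (-5) 13 (-2) 5, Zmx 5 2 2 1, Zmx (-1) 3 0 (-1));
  (Zmx (-5) 13 3 (-8), Zmx 5 2 (-3) (-1), Zmx (-1) 3 0 (-1));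
  (Zmx (-5) 17 2 (-7), Zmx 5 3 (-2) (-1), Zmx (-1) 4 0 (-1));
  (Zmx (-5) 18 3 (-11), Zmx 5 2 (-3) (-1), Zmx (-1) 4 0 (-1));
  (Zmx (-5) 22 2 (-9), Zmx 5 3 (-2) (-1), Zmx (-1) 5 0 (-1));
  (Zmx (-5) 23 3 (-14), Zmx 5 2 (-3) (-1), Zmx (-1) 5 0 (-1));
  (Zmx (-5) 28 3 (-17), Zmx 5 2 (-3) (-1), Zmx (-1) 6 0 (-1));
  (Zmx (-5) 33 3 (-20), Zmx 5 2 (-3) (-1), Zmx (-1) 7 0 (-1));
  (Zmx (-4) (-11) (-1) (-3), Zmx 1 0 0 1, Zmx 1 4 (-1) (-3));
  (Zmx (-4) (-11) 3 8, Zmx 1 1 (-1) 0, Zmx 2 7 (-1) (-3));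
  (Zmx (-4) (-9) (-3) (-7), Zmx 1 (-1) 1 0, Zmx (-3) (-7) 1 2);
  (Zmx (-4) (-9) 1 2, Zmx 1 0 0 1, Zmx (-4) (-9) 1 2);
  (Zmx (-4) (-3) 11 8, Zmx 1 0 (-3) 1, Zmx 1 2 (-1) (-1));
  (Zmx (-4) (-3) 15 11, Zmx 0 (-1) 1 0, Zmx (-5) (-4) 4 3);
  (Zmx (-4) (-1) 9 2, Zmx 1 1 (-2) (-1), Zmx (-5) (-1) 1 0);
  (Zmx (-4) (-1) 13 3, Zmx 0 (-1) 1 0, Zmx (-7) (-2) 4 1);
  (Zmx (-4) (-1) 17 4, Zmx 0 (-1) 1 0, Zmx (-3) (-1) 4 1);
  (Zmx (-4) (-1) 21 5, Zmx 0 (-1) 1 0, Zmx 1 0 4 1);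
  (Zmx (-4) (-1) 25 6, Zmx 0 (-1) 1 0, Zmx 5 1 4 1);
  (Zmx (-4) (-1) 29 7, Zmx 0 (-1) 1 0, Zmx 9 2 4 1);
  (Zmx (-4) (-1) 33 8, Zmx 0 (-1) 1 0, Zmx 13 3 4 1);
  (Zmx (-4) (-1) 37 9, Zmx 0 (-1) 1 0, Zmx 17 4 4 1);
  (Zmx (-4) 1 11 (-3), Zmx 1 0 (-3) 1, Zmx 1 1 (-1) 0);
  (Zmx (-4) 1 15 (-4), Zmx 0 (-1) 1 0, Zmx (-5) 1 4 (-1));
  (Zmx (-4) 1 19 (-5), Zmx 0 (-1) 1 0, Zmx (-1) 0 4 (-1));
  (Zmx (-4) 1 23 (-6), Zmx 0 (-1) 1 0, Zmx 3 (-1) 4 (-1));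
  (Zmx (-4) 1 27 (-7), Zmx 0 (-1) 1 0, Zmx 7 (-2) 4 (-1));
  (Zmx (-4) 1 31 (-8), Zmx 0 (-1) 1 0, Zmx 11 (-3) 4 (-1));
  (Zmx (-4) 3 9 (-7), Zmx 1 1 (-2) (-1), Zmx (-5) 4 1 (-1));
  (Zmx (-4) 3 13 (-10), Zmx 0 (-1) 1 0, Zmx (-7) 5 4 (-3));
  (Zmx (-4) 3 17 (-13), Zmx 0 (-1) 1 0, Zmx (-3) 2 4 (-3));
  (Zmx (-4) 3 21 (-16), Zmx 0 (-1) 1 0, Zmx 1 (-1) 4 (-3));
  (Zmx (-4) 3 25 (-19), Zmx 0 (-1) 1 0, Zmx 5 (-4) 4 (-3));
  (Zmx (-4) 7 (-7) 12, Zmx 1 0 2 1, Zmx (-4) 7 1 (-2));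
  (Zmx (-4) 7 5 (-9), Zmx 1 1 (-1) 0, Zmx (-5) 9 1 (-2));
  (Zmx (-4) 9 (-1) 2, Zmx 1 0 0 1, Zmx 1 (-1) (-1) 2);
  (Zmx (-4) 9 3 (-7), Zmx 4 (-1) (-3) 1, Zmx (-1) 2 0 (-1));
  (Zmx (-4) 11 (-3) 8, Zmx 1 (-1) 1 0, Zmx (-3) 8 1 (-3));
  (Zmx (-4) 11 1 (-3), Zmx 4 1 (-1) 0, Zmx (-1) 3 0 (-1));
  (Zmx (-4) 13 3 (-10), Zmx 4 (-1) (-3) 1, Zmx (-1) 3 0 (-1));
  (Zmx (-4) 15 1 (-4), Zmx 4 1 (-1) 0, Zmx (-1) 4 0 (-1));
  (Zmx (-4) 17 3 (-13), Zmx 4 (-1) (-3) 1, Zmx (-1) 4 0 (-1));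
  (Zmx (-4) 19 1 (-5), Zmx 4 1 (-1) 0, Zmx (-1) 5 0 (-1));
  (Zmx (-4) 21 3 (-16), Zmx 4 (-1) (-3) 1, Zmx (-1) 5 0 (-1));
  (Zmx (-4) 23 1 (-6), Zmx 4 1 (-1) 0, Zmx (-1) 6 0 (-1));
  (Zmx (-4) 25 3 (-19), Zmx 4 (-1) (-3) 1, Zmx (-1) 6 0 (-1));
  (Zmx (-4) 27 1 (-7), Zmx 4 1 (-1) 0, Zmx (-1) 7 0 (-1));
  (Zmx (-4) 29 3 (-22), Zmx 4 (-1) (-3) 1, Zmx (-1) 7 0 (-1));
  (Zmx (-4) 31 1 (-8), Zmx 4 1 (-1) 0, Zmx (-1) 8 0 (-1));
  (Zmx (-4) 33 3 (-25), Zmx 4 (-1) (-3) 1, Zmx (-1) 8 0 (-1));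
  (Zmx (-4) 37 3 (-28), Zmx 4 (-1) (-3) 1, Zmx (-1) 9 0 (-1));
  (Zmx (-3) (-11) (-1) (-4), Zmx 3 (-1) 1 0, Zmx (-1) 1 0 (-1));
  (Zmx (-3) (-11) 2 7, Zmx 3 2 (-2) (-1), Zmx (-1) 2 0 (-1));
  (Zmx (-3) (-10) (-2) (-7), Zmx 1 (-1) 1 0, Zmx (-2) (-7) 1 3);
  (Zmx (-3) (-10) 1 3, Zmx 3 1 (-1) 0, Zmx (-1) 2 0 (-1));
  (Zmx (-3) (-7) (-5) (-12), Zmx 1 0 2 1, Zmx (-3) (-7) 1 2);
  (Zmx (-3) (-7) 4 9, Zmx 1 1 (-1) 0, Zmx (-4) (-9) 1 2);
  (Zmx (-3) (-5) (-7) (-12), Zmx 1 0 2 1, Zmx 2 5 (-1) (-2));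
  (Zmx (-3) (-5) 8 13, Zmx 0 (-1) 1 0, Zmx (-7) (-12) 3 5);
  (Zmx (-3) (-5) 11 18, Zmx 0 (-1) 1 0, Zmx (-4) (-7) 3 5);
  (Zmx (-3) (-5) 14 23, Zmx 0 (-1) 1 0, Zmx (-1) (-2) 3 5);
  (Zmx (-3) (-2) 11 7, Zmx 0 (-1) 1 0, Zmx (-4) (-3) 3 2);
  (Zmx (-3) (-2) 14 9, Zmx 0 (-1) 1 0, Zmx (-1) (-1) 3 2);
  (Zmx (-3) (-1) 10 3, Zmx 1 0 (-3) 1, Zmx (-3) (-1) 1 0);
  (Zmx (-3) (-1) 13 4, Zmx 0 (-1) 1 0, Zmx (-2) (-1) 3 1);
  (Zmx (-3) (-1) 16 5, Zmx 0 (-1) 1 0, Zmx 1 0 3 1);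
  (Zmx (-3) (-1) 19 6, Zmx 0 (-1) 1 0, Zmx 4 1 3 1);
  (Zmx (-3) (-1) 22 7, Zmx 0 (-1) 1 0, Zmx 7 2 3 1);
  (Zmx (-3) (-1) 25 8, Zmx 0 (-1) 1 0, Zmx 10 3 3 1);
  (Zmx (-3) (-1) 28 9, Zmx 0 (-1) 1 0, Zmx 13 4 3 1);
  (Zmx (-3) 1 11 (-4), Zmx 0 (-1) 1 0, Zmx (-4) 1 3 (-1));
  (Zmx (-3) 1 14 (-5), Zmx 0 (-1) 1 0, Zmx (-1) 0 3 (-1));
  (Zmx (-3) 1 17 (-6), Zmx 0 (-1) 1 0, Zmx 2 (-1) 3 (-1));
  (Zmx (-3) 1 20 (-7), Zmx 0 (-1) 1 0, Zmx 5 (-2) 3 (-1));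
  (Zmx (-3) 1 23 (-8), Zmx 0 (-1) 1 0, Zmx 8 (-3) 3 (-1));
  (Zmx (-3) 2 10 (-7), Zmx 1 0 (-3) 1, Zmx (-3) 2 1 (-1));
  (Zmx (-3) 2 13 (-9), Zmx 0 (-1) 1 0, Zmx (-2) 1 3 (-2));
  (Zmx (-3) 2 16 (-11), Zmx 0 (-1) 1 0, Zmx 1 (-1) 3 (-2));
  (Zmx (-3) 2 19 (-13), Zmx 0 (-1) 1 0, Zmx 4 (-3) 3 (-2));
  (Zmx (-3) 4 8 (-11), Zmx 1 0 (-3) 1, Zmx 2 (-1) (-1) 1);
  (Zmx (-3) 4 11 (-15), Zmx 0 (-1) 1 0, Zmx (-4) 5 3 (-4));
  (Zmx (-3) 5 7 (-12), Zmx 1 1 (-2) (-1), Zmx (-4) 7 1 (-2));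
  (Zmx (-3) 5 10 (-17), Zmx 0 (-1) 1 0, Zmx (-5) 8 3 (-5));
  (Zmx (-3) 5 13 (-22), Zmx 0 (-1) 1 0, Zmx (-2) 3 3 (-5));
  (Zmx (-3) 7 5 (-12), Zmx 1 1 (-2) (-1), Zmx 3 (-5) (-1) 2);
  (Zmx (-3) 8 (-5) 13, Zmx 3 1 5 2, Zmx (-1) 3 0 (-1));
  (Zmx (-3) 8 4 (-11), Zmx 3 1 (-4) (-1), Zmx (-1) 3 0 (-1));
  (Zmx (-3) 10 (-1) 3, Zmx 1 0 0 1, Zmx 2 (-5) (-1) 3);
  (Zmx (-3) 10 2 (-7), Zmx 3 2 (-2) (-1), Zmx (-1) 4 0 (-1));
  (Zmx (-3) 10 5 (-17), Zmx 3 (-1) (-5) 2, Zmx (-1) 3 0 (-1));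
  (Zmx (-3) 11 (-2) 7, Zmx 3 1 2 1, Zmx (-1) 4 0 (-1));
  (Zmx (-3) 11 1 (-4), Zmx 3 1 (-1) 0, Zmx (-1) 4 0 (-1));
  (Zmx (-3) 11 4 (-15), Zmx 3 1 (-4) (-1), Zmx (-1) 4 0 (-1));
  (Zmx (-3) 13 2 (-9), Zmx 3 2 (-2) (-1), Zmx (-1) 5 0 (-1));
  (Zmx (-3) 13 5 (-22), Zmx 3 (-1) (-5) 2, Zmx (-1) 4 0 (-1));
  (Zmx (-3) 14 (-2) 9, Zmx 3 1 2 1, Zmx (-1) 5 0 (-1));
  (Zmx (-3) 14 1 (-5), Zmx 3 1 (-1) 0, Zmx (-1) 5 0 (-1));
  (Zmx (-3) 14 4 (-19), Zmx 3 1 (-4) (-1), Zmx (-1) 5 0 (-1));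
  (Zmx (-3) 16 2 (-11), Zmx 3 2 (-2) (-1), Zmx (-1) 6 0 (-1));
  (Zmx (-3) 17 1 (-6), Zmx 3 1 (-1) 0, Zmx (-1) 6 0 (-1));
  (Zmx (-3) 17 4 (-23), Zmx 3 1 (-4) (-1), Zmx (-1) 6 0 (-1));
  (Zmx (-3) 19 2 (-13), Zmx 3 2 (-2) (-1), Zmx (-1) 7 0 (-1));
  (Zmx (-3) 20 1 (-7), Zmx 3 1 (-1) 0, Zmx (-1) 7 0 (-1));
  (Zmx (-3) 20 4 (-27), Zmx 3 1 (-4) (-1), Zmx (-1) 7 0 (-1));
  (Zmx (-3) 22 2 (-15), Zmx 3 2 (-2) (-1), Zmx (-1) 8 0 (-1));
  (Zmx (-3) 23 1 (-8), Zmx 3 1 (-1) 0, Zmx (-1) 8 0 (-1));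
  (Zmx (-3) 23 4 (-31), Zmx 3 1 (-4) (-1), Zmx (-1) 8 0 (-1));
  (Zmx (-3) 25 2 (-17), Zmx 3 2 (-2) (-1), Zmx (-1) 9 0 (-1));
  (Zmx (-3) 28 2 (-19), Zmx 3 2 (-2) (-1), Zmx (-1) 10 0 (-1));
  (Zmx (-2) (-9) (-1) (-5), Zmx 2 (-1) 1 0, Zmx (-1) 0 0 (-1));
  (Zmx (-2) (-9) 1 4, Zmx 2 1 (-1) 0, Zmx (-1) 1 0 (-1));
  (Zmx (-2) (-5) 5 12, Zmx 1 1 (-2) (-1), Zmx (-3) (-7) 1 2);
  (Zmx (-2) (-5) 7 17, Zmx 0 (-1) 1 0, Zmx (-3) (-8) 2 5);
  (Zmx (-2) (-3) 7 10, Zmx 1 0 (-3) 1, Zmx (-2) (-3) 1 1);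
  (Zmx (-2) (-3) 9 13, Zmx 0 (-1) 1 0, Zmx (-1) (-2) 2 3);
  (Zmx (-2) (-3) 11 16, Zmx 0 (-1) 1 0, Zmx 1 1 2 3);
  (Zmx (-2) (-1) 9 4, Zmx 0 (-1) 1 0, Zmx (-1) (-1) 2 1);
  (Zmx (-2) (-1) 11 5, Zmx 0 (-1) 1 0, Zmx 1 0 2 1);
  (Zmx (-2) (-1) 13 6, Zmx 0 (-1) 1 0, Zmx 3 1 2 1);
  (Zmx (-2) (-1) 15 7, Zmx 0 (-1) 1 0, Zmx 5 2 2 1);
  (Zmx (-2) (-1) 17 8, Zmx 0 (-1) 1 0, Zmx 7 3 2 1);
  (Zmx (-2) (-1) 19 9, Zmx 0 (-1) 1 0, Zmx 9 4 2 1);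
  (Zmx (-2) 1 9 (-5), Zmx 0 (-1) 1 0, Zmx (-1) 0 2 (-1));
  (Zmx (-2) 1 11 (-6), Zmx 0 (-1) 1 0, Zmx 1 (-1) 2 (-1));
  (Zmx (-2) 1 13 (-7), Zmx 0 (-1) 1 0, Zmx 3 (-2) 2 (-1));
  (Zmx (-2) 1 15 (-8), Zmx 0 (-1) 1 0, Zmx 5 (-3) 2 (-1));
  (Zmx (-2) 3 7 (-11), Zmx 0 (-1) 1 0, Zmx (-3) 4 2 (-3));
  (Zmx (-2) 3 9 (-14), Zmx 0 (-1) 1 0, Zmx (-1) 1 2 (-3));
  (Zmx (-2) 5 5 (-13), Zmx 2 1 (-5) (-2), Zmx (-1) 3 0 (-1));
  (Zmx (-2) 5 7 (-18), Zmx 2 1 (-7) (-3), Zmx (-1) 3 0 (-1));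
  (Zmx (-2) 7 (-3) 10, Zmx 1 (-1) 1 0, Zmx 2 (-5) (-1) 3);
  (Zmx (-2) 7 3 (-11), Zmx 2 1 (-3) (-1), Zmx (-1) 4 0 (-1));
  (Zmx (-2) 7 5 (-18), Zmx 2 1 (-5) (-2), Zmx (-1) 4 0 (-1));
  (Zmx (-2) 9 (-3) 13, Zmx 2 (-1) 3 (-1), Zmx (-1) 4 0 (-1));
  (Zmx (-2) 9 (-1) 4, Zmx 2 (-1) 1 0, Zmx (-1) 4 0 (-1));
  (Zmx (-2) 9 1 (-5), Zmx 2 1 (-1) 0, Zmx (-1) 5 0 (-1));
  (Zmx (-2) 9 3 (-14), Zmx 2 1 (-3) (-1), Zmx (-1) 5 0 (-1));
  (Zmx (-2) 9 5 (-23), Zmx 2 1 (-5) (-2), Zmx (-1) 5 0 (-1));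
  (Zmx (-2) 11 (-1) 5, Zmx 2 (-1) 1 0, Zmx (-1) 5 0 (-1));
  (Zmx (-2) 11 1 (-6), Zmx 2 1 (-1) 0, Zmx (-1) 6 0 (-1));
  (Zmx (-2) 11 3 (-17), Zmx 2 1 (-3) (-1), Zmx (-1) 6 0 (-1));
  (Zmx (-2) 11 5 (-28), Zmx 2 1 (-5) (-2), Zmx (-1) 6 0 (-1));
  (Zmx (-2) 13 (-1) 6, Zmx 2 (-1) 1 0, Zmx (-1) 6 0 (-1));
  (Zmx (-2) 13 1 (-7), Zmx 2 1 (-1) 0, Zmx (-1) 7 0 (-1));
  (Zmx (-2) 13 3 (-20), Zmx 2 1 (-3) (-1), Zmx (-1) 7 0 (-1));
  (Zmx (-2) 13 5 (-33), Zmx 2 1 (-5) (-2), Zmx (-1) 7 0 (-1));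
  (Zmx (-2) 15 (-1) 7, Zmx 2 (-1) 1 0, Zmx (-1) 7 0 (-1));
  (Zmx (-2) 15 1 (-8), Zmx 2 1 (-1) 0, Zmx (-1) 8 0 (-1));
  (Zmx (-2) 15 3 (-23), Zmx 2 1 (-3) (-1), Zmx (-1) 8 0 (-1));
  (Zmx (-2) 17 (-1) 8, Zmx 2 (-1) 1 0, Zmx (-1) 8 0 (-1));
  (Zmx (-2) 17 1 (-9), Zmx 2 1 (-1) 0, Zmx (-1) 9 0 (-1));
  (Zmx (-2) 19 (-1) 9, Zmx 2 (-1) 1 0, Zmx (-1) 9 0 (-1));
  (Zmx (-2) 19 1 (-10), Zmx 2 1 (-1) 0, Zmx (-1) 10 0 (-1));
  (Zmx (-1) (-9) 0 (-1), Zmx 1 0 0 1, Zmx (-1) (-4) 0 (-1));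
  (Zmx (-1) (-9) 1 8, Zmx 1 1 (-1) 0, Zmx (-1) (-3) 0 (-1));
  (Zmx (-1) (-3) 4 11, Zmx 0 (-1) 1 0, Zmx (-1) (-4) 1 3);
  (Zmx (-1) (-3) 5 14, Zmx 0 (-1) 1 0, Zmx 0 (-1) 1 3);
  (Zmx (-1) (-2) 5 9, Zmx 0 (-1) 1 0, Zmx 0 (-1) 1 2);
  (Zmx (-1) (-2) 6 11, Zmx 0 (-1) 1 0, Zmx 1 1 1 2);
  (Zmx (-1) (-1) 9 8, Zmx 0 (-1) 1 0, Zmx 4 3 1 1);
  (Zmx (-1) (-1) 10 9, Zmx 0 (-1) 1 0, Zmx 5 4 1 1);
  (Zmx (-1) 3 3 (-10), Zmx 1 0 (-3) 1, Zmx (-1) 3 0 (-1));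
  (Zmx (-1) 4 2 (-9), Zmx 1 1 (-2) (-1), Zmx (-1) 5 0 (-1));
  (Zmx (-1) 4 3 (-13), Zmx 1 0 (-3) 1, Zmx (-1) 4 0 (-1));
  (Zmx (-1) 5 (-2) 9, Zmx 1 0 2 1, Zmx (-1) 5 0 (-1));
  (Zmx (-1) 5 2 (-11), Zmx 1 1 (-2) (-1), Zmx (-1) 6 0 (-1));
  (Zmx (-1) 5 3 (-16), Zmx 1 0 (-3) 1, Zmx (-1) 5 0 (-1));
  (Zmx (-1) 6 2 (-13), Zmx 1 1 (-2) (-1), Zmx (-1) 7 0 (-1));
  (Zmx (-1) 6 3 (-19), Zmx 1 0 (-3) 1, Zmx (-1) 6 0 (-1));
  (Zmx (-1) 7 2 (-15), Zmx 1 1 (-2) (-1), Zmx (-1) 8 0 (-1));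
  (Zmx (-1) 9 (-1) 8, Zmx 1 (-1) 1 0, Zmx (-1) 8 0 (-1));
  (Zmx (-1) 9 0 (-1), Zmx 1 0 0 1, Zmx (-1) 9 0 (-1));
  (Zmx (-1) 10 (-1) 9, Zmx 1 (-1) 1 0, Zmx (-1) 9 0 (-1));
  (Zmx (-1) 10 0 (-1), Zmx 1 0 0 1, Zmx (-1) 10 0 (-1));
  (Zmx 0 (-1) 1 9, Zmx 0 (-1) 1 0, Zmx 1 4 0 1);
  (Zmx 0 1 (-1) (-9), Zmx 0 (-1) 1 0, Zmx (-1) (-4) 0 (-1));
  (Zmx 0 1 (-1) 9, Zmx 0 (-1) 1 0, Zmx (-1) 9 0 (-1));
  (Zmx 1 (-9) 0 1, Zmx 1 0 0 1, Zmx 1 (-9) 0 1);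
  (Zmx 1 (-9) 1 (-8), Zmx 1 0 0 1, Zmx (-4) 31 1 (-8));
  (Zmx 1 (-8) (-2) 17, Zmx 1 1 (-1) 0, Zmx 2 (-17) (-1) 9);
  (Zmx 1 (-8) (-1) 9, Zmx 1 1 (-1) 0, Zmx 1 (-9) 0 1);
  (Zmx 1 (-7) (-2) 15, Zmx 1 1 (-1) 0, Zmx 2 (-15) (-1) 8);
  (Zmx 1 (-6) (-2) 13, Zmx 1 1 (-1) 0, Zmx 2 (-13) (-1) 7);
  (Zmx 1 (-5) (-2) 11, Zmx 1 1 (-1) 0, Zmx 2 (-11) (-1) 6);
  (Zmx 1 (-4) (-2) 9, Zmx 1 1 (-1) 0, Zmx 2 (-9) (-1) 5);
  (Zmx 1 (-3) (-3) 10, Zmx 1 0 (-3) 1, Zmx 1 (-3) 0 1);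
  (Zmx 1 (-2) (-5) 11, Zmx 1 0 (-6) 1, Zmx (-4) 3 1 (-1));
  (Zmx 1 (-2) (-4) 9, Zmx 1 0 (-5) 1, Zmx (-4) 3 1 (-1));
  (Zmx 1 (-1) (-8) 9, Zmx 1 0 (-9) 1, Zmx (-4) (-1) 1 0);
  (Zmx 1 0 (-9) 1, Zmx 0 (-1) 1 0, Zmx (-4) 1 (-1) 0);
  (Zmx 1 1 (-9) (-8), Zmx 1 0 (-8) 1, Zmx 1 1 (-1) 0);
  (Zmx 1 2 (-5) (-9), Zmx 1 0 (-4) 1, Zmx 1 2 (-1) (-1));
  (Zmx 1 3 (-5) (-14), Zmx 1 0 (-5) 1, Zmx 1 (-2) 0 1);
  (Zmx 1 3 (-4) (-11), Zmx 1 0 (-4) 1, Zmx 1 (-2) 0 1);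
  (Zmx 1 5 (-2) (-9), Zmx 1 1 (-2) (-1), Zmx 1 (-1) 0 1);
  (Zmx 1 6 (-2) (-11), Zmx 1 1 (-2) (-1), Zmx 1 0 0 1);
  (Zmx 1 7 (-2) (-13), Zmx 1 1 (-2) (-1), Zmx 1 1 0 1);
  (Zmx 1 8 (-2) (-15), Zmx 1 1 (-2) (-1), Zmx 1 2 0 1);
  (Zmx 1 9 (-2) (-17), Zmx 1 1 (-2) (-1), Zmx 1 3 0 1);
  (Zmx 1 9 (-1) (-8), Zmx 1 1 (-1) 0, Zmx 1 3 0 1);
  (Zmx 1 9 0 1, Zmx 1 0 0 1, Zmx 1 4 0 1);
  (Zmx 2 (-17) (-3) 26, Zmx 1 1 (-1) 0, Zmx 3 (-26) (-1) 9);
  (Zmx 2 (-17) (-1) 9, Zmx 1 1 (-1) 0, Zmx (-4) 31 1 (-8));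
  (Zmx 2 (-15) (-3) 23, Zmx 1 1 (-1) 0, Zmx 3 (-23) (-1) 8);
  (Zmx 2 (-15) (-1) 8, Zmx 1 1 (-1) 0, Zmx (-4) 27 1 (-7));
  (Zmx 2 (-15) 1 (-7), Zmx 1 0 0 1, Zmx (-3) 20 1 (-7));
  (Zmx 2 (-13) (-3) 20, Zmx 1 1 (-1) 0, Zmx 3 (-20) (-1) 7);
  (Zmx 2 (-13) (-1) 7, Zmx 1 1 (-1) 0, Zmx (-4) 23 1 (-6));
  (Zmx 2 (-13) 1 (-6), Zmx 1 0 0 1, Zmx (-3) 17 1 (-6));
  (Zmx 2 (-11) (-3) 17, Zmx 1 1 (-1) 0, Zmx 3 (-17) (-1) 6);
  (Zmx 2 (-11) (-1) 6, Zmx 1 1 (-1) 0, Zmx (-4) 19 1 (-5));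
  (Zmx 2 (-11) 1 (-5), Zmx 1 0 0 1, Zmx (-3) 14 1 (-5));
  (Zmx 2 (-9) (-3) 14, Zmx 1 1 (-1) 0, Zmx 3 (-14) (-1) 5);
  (Zmx 2 (-9) (-1) 5, Zmx 2 1 (-1) 0, Zmx 1 (-5) 0 1);
  (Zmx 2 (-9) 1 (-4), Zmx 1 0 0 1, Zmx (-3) 11 1 (-4));
  (Zmx 2 (-7) (-5) 18, Zmx 1 1 (-2) (-1), Zmx 3 (-11) (-1) 4);
  (Zmx 2 (-7) (-3) 11, Zmx 2 1 (-3) (-1), Zmx 1 (-4) 0 1);
  (Zmx 2 (-5) (-7) 18, Zmx 1 0 (-4) 1, Zmx (-3) 5 1 (-2));
  (Zmx 2 (-5) (-5) 13, Zmx 1 1 (-2) (-1), Zmx 3 (-8) (-1) 3);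
  (Zmx 2 (-3) (-9) 14, Zmx 1 0 (-5) 1, Zmx (-3) 2 1 (-1));
  (Zmx 2 (-3) (-7) 11, Zmx 1 0 (-4) 1, Zmx (-3) 2 1 (-1));
  (Zmx 2 (-1) (-9) 5, Zmx 1 0 (-4) 1, Zmx 2 (-1) (-1) 1);
  (Zmx 2 1 (-9) (-4), Zmx 1 0 (-4) 1, Zmx 2 1 (-1) 0);
  (Zmx 2 3 (-9) (-13), Zmx 1 0 (-4) 1, Zmx 2 3 (-1) (-1));
  (Zmx 2 3 (-7) (-10), Zmx 1 0 (-3) 1, Zmx 2 3 (-1) (-1));
  (Zmx 2 5 (-9) (-22), Zmx 1 0 (-4) 1, Zmx 2 5 (-1) (-2));
  (Zmx 2 5 (-7) (-17), Zmx 2 1 (-7) (-3), Zmx 1 (-3) 0 1);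
  (Zmx 2 5 (-5) (-12), Zmx 2 1 (-5) (-2), Zmx 1 (-3) 0 1);
  (Zmx 2 7 (-9) (-31), Zmx 2 1 (-9) (-4), Zmx 1 (-2) 0 1);
  (Zmx 2 7 (-7) (-24), Zmx 2 1 (-7) (-3), Zmx 1 (-2) 0 1);
  (Zmx 2 7 (-5) (-17), Zmx 2 1 (-5) (-2), Zmx 1 (-2) 0 1);
  (Zmx 2 7 (-3) (-10), Zmx 2 1 (-3) (-1), Zmx 1 (-2) 0 1);
  (Zmx 2 9 (-9) (-40), Zmx 2 1 (-9) (-4), Zmx 1 (-1) 0 1);
  (Zmx 2 9 (-7) (-31), Zmx 2 1 (-7) (-3), Zmx 1 (-1) 0 1);
  (Zmx 2 9 (-5) (-22), Zmx 2 1 (-5) (-2), Zmx 1 (-1) 0 1);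
  (Zmx 2 9 (-3) (-13), Zmx 2 1 (-3) (-1), Zmx 1 (-1) 0 1);
  (Zmx 2 9 (-1) (-4), Zmx 2 1 (-1) 0, Zmx 1 (-1) 0 1);
  (Zmx 2 9 1 5, Zmx 0 (-1) 1 0, Zmx 1 5 (-2) (-9));
  (Zmx 2 11 (-3) (-16), Zmx 2 1 (-3) (-1), Zmx 1 0 0 1);
  (Zmx 2 11 (-1) (-5), Zmx 2 1 (-1) 0, Zmx 1 0 0 1);
  (Zmx 2 11 1 6, Zmx 2 (-1) 1 0, Zmx 1 1 0 1);
  (Zmx 2 13 (-3) (-19), Zmx 2 1 (-3) (-1), Zmx 1 1 0 1);
  (Zmx 2 13 (-1) (-6), Zmx 2 1 (-1) 0, Zmx 1 1 0 1);
  (Zmx 2 13 1 7, Zmx 2 (-1) 1 0, Zmx 1 2 0 1);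
  (Zmx 2 15 (-3) (-22), Zmx 2 1 (-3) (-1), Zmx 1 2 0 1);
  (Zmx 2 15 (-1) (-7), Zmx 2 1 (-1) 0, Zmx 1 2 0 1);
  (Zmx 2 15 1 8, Zmx 2 (-1) 1 0, Zmx 1 3 0 1);
  (Zmx 2 17 (-3) (-25), Zmx 2 1 (-3) (-1), Zmx 1 3 0 1);
  (Zmx 2 17 (-1) (-8), Zmx 2 1 (-1) 0, Zmx 1 3 0 1);
  (Zmx 3 (-26) (-4) 35, Zmx 1 1 (-1) 0, Zmx 4 (-35) (-1) 9);
  (Zmx 3 (-26) (-1) 9, Zmx 1 0 0 1, Zmx 3 (-26) (-1) 9);
  (Zmx 3 (-25) (-2) 17, Zmx 1 1 (-1) 0, Zmx (-3) 23 1 (-8));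
  (Zmx 3 (-23) (-4) 31, Zmx 1 1 (-1) 0, Zmx 4 (-31) (-1) 8);
  (Zmx 3 (-23) (-1) 8, Zmx 1 0 0 1, Zmx 3 (-23) (-1) 8);
  (Zmx 3 (-22) (-5) 37, Zmx 1 1 (-2) (-1), Zmx (-3) 20 1 (-7));
  (Zmx 3 (-22) (-2) 15, Zmx 1 1 (-1) 0, Zmx (-3) 20 1 (-7));
  (Zmx 3 (-20) (-4) 27, Zmx 1 1 (-1) 0, Zmx 4 (-27) (-1) 7);
  (Zmx 3 (-20) (-1) 7, Zmx 1 0 0 1, Zmx 3 (-20) (-1) 7);
  (Zmx 3 (-19) (-5) 32, Zmx 1 1 (-2) (-1), Zmx (-3) 17 1 (-6));
  (Zmx 3 (-19) (-2) 13, Zmx 1 1 (-1) 0, Zmx (-3) 17 1 (-6));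
  (Zmx 3 (-17) (-4) 23, Zmx 1 1 (-1) 0, Zmx 4 (-23) (-1) 6);
  (Zmx 3 (-17) (-1) 6, Zmx 1 0 0 1, Zmx 3 (-17) (-1) 6);
  (Zmx 3 (-16) (-5) 27, Zmx 1 1 (-2) (-1), Zmx (-3) 14 1 (-5));
  (Zmx 3 (-16) (-2) 11, Zmx 1 1 (-1) 0, Zmx (-3) 14 1 (-5));
  (Zmx 3 (-14) (-4) 19, Zmx 1 1 (-1) 0, Zmx 4 (-19) (-1) 5);
  (Zmx 3 (-14) (-1) 5, Zmx 1 0 0 1, Zmx 3 (-14) (-1) 5);
  (Zmx 3 (-13) (-5) 22, Zmx 1 1 (-2) (-1), Zmx (-3) 11 1 (-4));
  (Zmx 3 (-13) (-2) 9, Zmx 1 1 (-1) 0, Zmx (-3) 11 1 (-4));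
  (Zmx 3 (-11) (-7) 26, Zmx 1 1 (-2) (-1), Zmx 4 (-15) (-1) 4);
  (Zmx 3 (-11) (-4) 15, Zmx 3 1 (-4) (-1), Zmx 1 (-9) 0 1);
  (Zmx 3 (-11) (-1) 4, Zmx 3 1 (-1) 0, Zmx 1 (-4) 0 1);
  (Zmx 3 (-11) 2 (-7), Zmx 1 (-1) 1 0, Zmx 2 (-7) (-1) 4);
  (Zmx 3 (-10) (-5) 17, Zmx 1 1 (-2) (-1), Zmx (-3) 8 1 (-3));
  (Zmx 3 (-10) (-2) 7, Zmx 3 2 (-2) (-1), Zmx 1 (-4) 0 1);
  (Zmx 3 (-10) 1 (-3), Zmx 1 0 0 1, Zmx (-2) 5 1 (-3));
  (Zmx 3 (-8) (-10) 27, Zmx 1 0 (-3) 1, Zmx 3 (-8) (-1) 3);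
  (Zmx 3 (-8) (-7) 19, Zmx 1 1 (-2) (-1), Zmx 4 (-11) (-1) 3);
  (Zmx 3 (-8) (-4) 11, Zmx 3 1 (-4) (-1), Zmx 1 (-8) 0 1);
  (Zmx 3 (-8) 5 (-13), Zmx 0 (-1) 1 0, Zmx 5 (-13) (-3) 8);
  (Zmx 3 (-7) (-5) 12, Zmx 3 (-1) (-5) 2, Zmx 1 (-7) 0 1);
  (Zmx 3 (-5) (-13) 22, Zmx 1 0 (-4) 1, Zmx 3 (-5) (-1) 2);
  (Zmx 3 (-5) (-10) 17, Zmx 1 0 (-3) 1, Zmx 3 (-5) (-1) 2);
  (Zmx 3 (-5) (-7) 12, Zmx 1 1 (-2) (-1), Zmx 4 (-7) (-1) 2);
  (Zmx 3 (-2) (-13) 9, Zmx 1 0 (-4) 1, Zmx 3 (-2) (-1) 1);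
  (Zmx 3 (-2) (-10) 7, Zmx 1 0 (-3) 1, Zmx 3 (-2) (-1) 1);
  (Zmx 3 (-1) (-14) 5, Zmx 1 0 (-5) 1, Zmx (-2) (-1) 1 0);
  (Zmx 3 (-1) (-11) 4, Zmx 1 0 (-4) 1, Zmx (-2) (-1) 1 0);
  (Zmx 3 1 (-13) (-4), Zmx 1 0 (-4) 1, Zmx 3 1 (-1) 0);
  (Zmx 3 1 (-10) (-3), Zmx 1 0 (-3) 1, Zmx 3 1 (-1) 0);
  (Zmx 3 2 (-14) (-9), Zmx 1 0 (-5) 1, Zmx (-2) (-3) 1 1);
  (Zmx 3 2 (-11) (-7), Zmx 1 0 (-4) 1, Zmx (-2) (-3) 1 1);
  (Zmx 3 4 (-13) (-17), Zmx 1 0 (-4) 1, Zmx 3 4 (-1) (-1));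
  (Zmx 3 4 (-10) (-13), Zmx 1 0 (-3) 1, Zmx 3 4 (-1) (-1));
  (Zmx 3 4 (-7) (-9), Zmx 3 1 (-7) (-2), Zmx 1 (-4) 0 1);
  (Zmx 3 7 (-13) (-30), Zmx 1 0 (-4) 1, Zmx 3 7 (-1) (-2));
  (Zmx 3 7 (-10) (-23), Zmx 3 1 (-10) (-3), Zmx 1 (-3) 0 1);
  (Zmx 3 7 (-4) (-9), Zmx 3 1 (-4) (-1), Zmx 1 (-3) 0 1);
  (Zmx 3 8 (-5) (-13), Zmx 3 (-1) (-5) 2, Zmx 1 (-2) 0 1);
  (Zmx 3 10 (-4) (-13), Zmx 3 1 (-4) (-1), Zmx 1 (-2) 0 1);
  (Zmx 3 10 (-1) (-3), Zmx 3 1 (-1) 0, Zmx 1 (-2) 0 1);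
  (Zmx 3 10 2 7, Zmx 1 (-1) 1 0, Zmx 2 7 (-1) (-3));
  (Zmx 3 11 (-2) (-7), Zmx 3 2 (-2) (-1), Zmx 1 (-2) 0 1);
  (Zmx 3 11 1 4, Zmx 1 0 0 1, Zmx (-2) (-9) 1 4);
  (Zmx 3 13 (-4) (-17), Zmx 3 1 (-4) (-1), Zmx 1 (-1) 0 1);
  (Zmx 3 13 (-1) (-4), Zmx 3 1 (-1) 0, Zmx 1 (-1) 0 1);
  (Zmx 3 16 (-4) (-21), Zmx 3 1 (-4) (-1), Zmx 1 0 0 1);
  (Zmx 3 16 (-1) (-5), Zmx 3 1 (-1) 0, Zmx 1 0 0 1);
  (Zmx 3 19 (-4) (-25), Zmx 3 1 (-4) (-1), Zmx 1 1 0 1);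
  (Zmx 3 19 (-1) (-6), Zmx 3 1 (-1) 0, Zmx 1 1 0 1);
  (Zmx 3 22 (-4) (-29), Zmx 3 1 (-4) (-1), Zmx 1 2 0 1);
  (Zmx 3 22 (-1) (-7), Zmx 3 1 (-1) 0, Zmx 1 2 0 1);
  (Zmx 3 25 (-4) (-33), Zmx 3 1 (-4) (-1), Zmx 1 3 0 1);
  (Zmx 3 25 (-1) (-8), Zmx 3 1 (-1) 0, Zmx 1 3 0 1);
  (Zmx 4 (-35) (-1) 9, Zmx 1 0 0 1, Zmx 4 (-35) (-1) 9);
  (Zmx 4 (-33) (-3) 25, Zmx 1 1 (-1) 0, Zmx (-2) 15 1 (-8));
  (Zmx 4 (-31) (-5) 39, Zmx 1 1 (-1) 0, Zmx 5 (-39) (-1) 8);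
  (Zmx 4 (-31) (-1) 8, Zmx 1 0 0 1, Zmx 4 (-31) (-1) 8);
  (Zmx 4 (-29) (-3) 22, Zmx 1 1 (-1) 0, Zmx (-2) 13 1 (-7));
  (Zmx 4 (-27) (-5) 34, Zmx 1 1 (-1) 0, Zmx 5 (-34) (-1) 7);
  (Zmx 4 (-27) (-1) 7, Zmx 1 0 0 1, Zmx 4 (-27) (-1) 7);
  (Zmx 4 (-25) (-3) 19, Zmx 1 1 (-1) 0, Zmx (-2) 11 1 (-6));
  (Zmx 4 (-23) (-5) 29, Zmx 1 1 (-1) 0, Zmx 5 (-29) (-1) 6);
  (Zmx 4 (-23) (-1) 6, Zmx 1 0 0 1, Zmx 4 (-23) (-1) 6);
  (Zmx 4 (-21) (-3) 16, Zmx 1 1 (-1) 0, Zmx (-2) 9 1 (-5));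
  (Zmx 4 (-19) (-5) 24, Zmx 1 1 (-1) 0, Zmx 5 (-24) (-1) 5);
  (Zmx 4 (-19) (-1) 5, Zmx 1 0 0 1, Zmx 4 (-19) (-1) 5);
  (Zmx 4 (-17) (-7) 30, Zmx 1 1 (-2) (-1), Zmx (-2) 7 1 (-4));
  (Zmx 4 (-17) (-3) 13, Zmx 1 1 (-1) 0, Zmx (-2) 7 1 (-4));
  (Zmx 4 (-15) (-9) 34, Zmx 1 1 (-2) (-1), Zmx 5 (-19) (-1) 4);
  (Zmx 4 (-15) (-5) 19, Zmx 1 1 (-1) 0, Zmx 5 (-19) (-1) 4);
  (Zmx 4 (-15) (-1) 4, Zmx 4 1 (-1) 0, Zmx 1 (-9) 0 1);
  (Zmx 4 (-13) (-7) 23, Zmx 1 1 (-2) (-1), Zmx (-2) 5 1 (-3));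
  (Zmx 4 (-13) (-3) 10, Zmx 4 (-1) (-3) 1, Zmx 1 (-8) 0 1);
  (Zmx 4 (-11) (-9) 25, Zmx 1 1 (-2) (-1), Zmx 5 (-14) (-1) 3);
  (Zmx 4 (-11) (-5) 14, Zmx 4 1 (-5) (-1), Zmx 1 (-8) 0 1);
  (Zmx 4 (-11) (-1) 3, Zmx 4 1 (-1) 0, Zmx 1 (-8) 0 1);
  (Zmx 4 (-11) 3 (-8), Zmx 1 (-1) 1 0, Zmx 3 (-8) (-1) 3);
  (Zmx 4 (-9) (-7) 16, Zmx 1 1 (-2) (-1), Zmx (-2) 3 1 (-2));
  (Zmx 4 (-9) (-3) 7, Zmx 4 (-1) (-3) 1, Zmx 1 (-7) 0 1);
  (Zmx 4 (-9) 1 (-2), Zmx 1 0 0 1, Zmx (-1) 1 1 (-2));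
  (Zmx 4 (-7) (-17) 30, Zmx 1 0 (-4) 1, Zmx 4 (-7) (-1) 2);
  (Zmx 4 (-7) (-13) 23, Zmx 1 0 (-3) 1, Zmx 4 (-7) (-1) 2);
  (Zmx 4 (-7) (-9) 16, Zmx 1 1 (-2) (-1), Zmx 5 (-9) (-1) 2);
  (Zmx 4 (-7) (-5) 9, Zmx 4 1 (-5) (-1), Zmx 1 (-7) 0 1);
  (Zmx 4 (-7) 7 (-12), Zmx 0 (-1) 1 0, Zmx 7 (-12) (-4) 7);
  (Zmx 4 (-5) (-7) 9, Zmx 1 1 (-2) (-1), Zmx (-2) 1 1 (-1));
  (Zmx 4 (-3) (-17) 13, Zmx 1 0 (-4) 1, Zmx 4 (-3) (-1) 1);
  (Zmx 4 (-3) (-13) 10, Zmx 1 0 (-3) 1, Zmx 4 (-3) (-1) 1);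
  (Zmx 4 (-3) (-9) 7, Zmx 1 1 (-2) (-1), Zmx 5 (-4) (-1) 1);
  (Zmx 4 1 (-17) (-4), Zmx 1 0 (-4) 1, Zmx 4 1 (-1) 0);
  (Zmx 4 1 (-13) (-3), Zmx 1 0 (-3) 1, Zmx 4 1 (-1) 0);
  (Zmx 4 1 (-9) (-2), Zmx 1 1 (-2) (-1), Zmx 5 1 (-1) 0);
  (Zmx 4 1 11 3, Zmx 0 (-1) 1 0, Zmx 11 3 (-4) (-1));
  (Zmx 4 5 (-17) (-21), Zmx 1 0 (-4) 1, Zmx 4 5 (-1) (-1));
  (Zmx 4 5 (-13) (-16), Zmx 1 0 (-3) 1, Zmx 4 5 (-1) (-1));
  (Zmx 4 5 (-9) (-11), Zmx 4 1 (-9) (-2), Zmx 1 (-4) 0 1);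
  (Zmx 4 9 (-17) (-38), Zmx 1 0 (-4) 1, Zmx 4 9 (-1) (-2));
  (Zmx 4 9 (-13) (-29), Zmx 1 0 (-3) 1, Zmx 4 9 (-1) (-2));
  (Zmx 4 9 (-9) (-20), Zmx 4 1 (-9) (-2), Zmx 1 (-3) 0 1);
  (Zmx 4 9 (-5) (-11), Zmx 4 1 (-5) (-1), Zmx 1 (-3) 0 1);
  (Zmx 4 9 (-1) (-2), Zmx 4 1 (-1) 0, Zmx 1 (-3) 0 1);
  (Zmx 4 9 3 7, Zmx 0 (-1) 1 0, Zmx 3 7 (-4) (-9));
  (Zmx 4 11 (-3) (-8), Zmx 4 (-1) (-3) 1, Zmx 1 (-2) 0 1);
  (Zmx 4 11 1 3, Zmx 1 0 0 1, Zmx (-1) (-4) 1 3);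
  (Zmx 5 (-39) (-1) 8, Zmx 1 0 0 1, Zmx 5 (-39) (-1) 8);
  (Zmx 5 (-37) (-2) 15, Zmx 2 1 (-1) 0, Zmx (-3) 20 1 (-7));
  (Zmx 5 (-36) (-4) 29, Zmx 1 1 (-1) 0, Zmx (-1) 6 1 (-7));
  (Zmx 5 (-34) (-1) 7, Zmx 1 0 0 1, Zmx 5 (-34) (-1) 7);
  (Zmx 5 (-32) (-2) 13, Zmx 2 1 (-1) 0, Zmx (-3) 17 1 (-6));
  (Zmx 5 (-31) (-4) 25, Zmx 1 1 (-1) 0, Zmx (-1) 5 1 (-6));
  (Zmx 5 (-29) (-1) 6, Zmx 1 0 0 1, Zmx 5 (-29) (-1) 6);
  (Zmx 5 (-27) (-2) 11, Zmx 2 1 (-1) 0, Zmx (-3) 14 1 (-5));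
  (Zmx 5 (-26) (-4) 21, Zmx 1 1 (-1) 0, Zmx (-1) 4 1 (-5));
  (Zmx 5 (-24) (-1) 5, Zmx 1 0 0 1, Zmx 5 (-24) (-1) 5);
  (Zmx 5 (-22) (-2) 9, Zmx 2 1 (-1) 0, Zmx (-3) 11 1 (-4));
  (Zmx 5 (-21) (-9) 38, Zmx 1 1 (-2) (-1), Zmx (-1) 3 1 (-4));
  (Zmx 5 (-21) (-4) 17, Zmx 1 1 (-1) 0, Zmx (-1) 3 1 (-4));
  (Zmx 5 (-19) (-6) 23, Zmx 1 1 (-1) 0, Zmx 6 (-23) (-1) 4);
  (Zmx 5 (-19) (-1) 4, Zmx 1 0 0 1, Zmx 5 (-19) (-1) 4);
  (Zmx 5 (-18) (-3) 11, Zmx 2 1 (-1) 0, Zmx 3 (-11) (-1) 4);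
  (Zmx 5 (-17) (-7) 24, Zmx 1 1 (-1) 0, Zmx 7 (-24) (-2) 7);
  (Zmx 5 (-17) (-2) 7, Zmx 2 1 (-1) 0, Zmx (-3) 8 1 (-3));
  (Zmx 5 (-16) (-9) 29, Zmx 1 1 (-2) (-1), Zmx (-1) 2 1 (-3));
  (Zmx 5 (-16) (-4) 13, Zmx 1 1 (-1) 0, Zmx (-1) 2 1 (-3));
  (Zmx 5 (-14) (-6) 17, Zmx 1 1 (-1) 0, Zmx 6 (-17) (-1) 3);
  (Zmx 5 (-14) (-1) 3, Zmx 5 1 (-1) 0, Zmx 1 (-8) 0 1);
  (Zmx 5 (-13) (-3) 8, Zmx 2 1 (-1) 0, Zmx 3 (-8) (-1) 3);
  (Zmx 5 (-13) 2 (-5), Zmx 1 0 0 1, Zmx (-5) 12 2 (-5));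
  (Zmx 5 (-12) (-7) 17, Zmx 1 1 (-1) 0, Zmx 7 (-17) (-2) 5);
  (Zmx 5 (-12) (-2) 5, Zmx 5 3 (-2) (-1), Zmx 1 (-8) 0 1);
  (Zmx 5 (-12) 3 (-7), Zmx 2 (-1) 1 0, Zmx (-2) 3 1 (-2));
  (Zmx 5 (-11) (-9) 20, Zmx 1 1 (-2) (-1), Zmx (-1) 1 1 (-2));
  (Zmx 5 (-11) (-4) 9, Zmx 5 (-1) (-4) 1, Zmx 1 (-7) 0 1);
  (Zmx 5 (-9) (-21) 38, Zmx 1 0 (-4) 1, Zmx 5 (-9) (-1) 2);
  (Zmx 5 (-9) (-16) 29, Zmx 1 0 (-3) 1, Zmx 5 (-9) (-1) 2);
  (Zmx 5 (-9) (-11) 20, Zmx 1 1 (-2) (-1), Zmx 6 (-11) (-1) 2);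
  (Zmx 5 (-9) (-6) 11, Zmx 1 1 (-1) 0, Zmx 6 (-11) (-1) 2);
  (Zmx 5 (-9) (-1) 2, Zmx 5 1 (-1) 0, Zmx 1 (-7) 0 1);
  (Zmx 5 (-9) 4 (-7), Zmx 0 (-1) 1 0, Zmx 4 (-7) (-5) 9);
  (Zmx 5 (-8) 7 (-11), Zmx 1 (-1) 1 0, Zmx (-3) 4 2 (-3));
  (Zmx 5 (-7) (-7) 10, Zmx 2 1 (-3) (-1), Zmx (-3) 2 1 (-1));
  (Zmx 5 (-6) (-9) 11, Zmx 1 1 (-2) (-1), Zmx (-1) 0 1 (-1));
  (Zmx 5 (-4) (-21) 17, Zmx 1 0 (-4) 1, Zmx 5 (-4) (-1) 1);
  (Zmx 5 (-4) (-16) 13, Zmx 1 0 (-3) 1, Zmx 5 (-4) (-1) 1);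
  (Zmx 5 (-4) (-11) 9, Zmx 1 1 (-2) (-1), Zmx 6 (-5) (-1) 1);
  (Zmx 5 (-2) (-22) 9, Zmx 2 1 (-9) (-4), Zmx (-3) (-1) 1 0);
  (Zmx 5 (-2) (-17) 7, Zmx 2 1 (-7) (-3), Zmx (-3) (-1) 1 0);
  (Zmx 5 (-2) (-12) 5, Zmx 2 1 (-5) (-2), Zmx (-3) (-1) 1 0);
  (Zmx 5 (-1) (-9) 2, Zmx 1 1 (-2) (-1), Zmx (-1) (-1) 1 0);
  (Zmx 5 1 (-21) (-4), Zmx 1 0 (-4) 1, Zmx 5 1 (-1) 0);
  (Zmx 5 1 (-16) (-3), Zmx 1 0 (-3) 1, Zmx 5 1 (-1) 0);
  (Zmx 5 1 (-11) (-2), Zmx 1 1 (-2) (-1), Zmx 6 1 (-1) 0);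
  (Zmx 5 2 (-18) (-7), Zmx 2 1 (-7) (-3), Zmx 3 1 (-1) 0);
  (Zmx 5 2 (-13) (-5), Zmx 2 1 (-5) (-2), Zmx 3 1 (-1) 0);
  (Zmx 5 3 (-22) (-13), Zmx 1 0 (-4) 1, Zmx 5 3 (-2) (-1));
  (Zmx 5 3 (-17) (-10), Zmx 1 0 (-3) 1, Zmx 5 3 (-2) (-1));
  (Zmx 5 3 (-12) (-7), Zmx 1 1 (-2) (-1), Zmx 7 4 (-2) (-1));
  (Zmx 5 4 (-9) (-7), Zmx 5 (-1) (-9) 2, Zmx 1 (-4) 0 1);
  (Zmx 5 6 (-21) (-25), Zmx 1 0 (-4) 1, Zmx 5 6 (-1) (-1));
  (Zmx 5 6 (-16) (-19), Zmx 1 0 (-3) 1, Zmx 5 6 (-1) (-1));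
  (Zmx 5 6 (-11) (-13), Zmx 1 1 (-2) (-1), Zmx 6 7 (-1) (-1));
  (Zmx 5 7 (-8) (-11), Zmx 2 1 (-3) (-1), Zmx 3 4 (-1) (-1));
  (Zmx 5 8 (-7) (-11), Zmx 5 (-2) (-7) 3, Zmx 1 (-3) 0 1);
  (Zmx 5 9 (-4) (-7), Zmx 5 (-1) (-4) 1, Zmx 1 (-3) 0 1);
  (Zmx 5 9 1 2, Zmx 1 0 0 1, Zmx 0 (-1) 1 2);
  (Zmx 5 12 (-3) (-7), Zmx 5 2 (-3) (-1), Zmx 1 (-3) 0 1);
  (Zmx 5 12 2 5, Zmx 2 (-1) 1 0, Zmx 2 5 (-1) (-2));
  (Zmx 5 13 (-2) (-5), Zmx 5 3 (-2) (-1), Zmx 1 (-3) 0 1);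
  (Zmx 5 13 3 8, Zmx 5 (-2) 3 (-1), Zmx 1 (-2) 0 1);
  (Zmx 6 (-25) (-5) 21, Zmx 1 1 (-1) 0, Zmx 0 (-1) 1 (-4));
  (Zmx 6 (-23) (-7) 27, Zmx 1 1 (-1) 0, Zmx 7 (-27) (-1) 4);
  (Zmx 6 (-23) (-1) 4, Zmx 1 0 0 1, Zmx 6 (-23) (-1) 4);
  (Zmx 6 (-19) (-5) 16, Zmx 1 1 (-1) 0, Zmx 0 (-1) 1 (-3));
  (Zmx 6 (-17) (-7) 20, Zmx 1 1 (-1) 0, Zmx 7 (-20) (-1) 3);
  (Zmx 6 (-17) (-1) 3, Zmx 1 0 0 1, Zmx 6 (-17) (-1) 3);
  (Zmx 6 (-13) (-5) 11, Zmx 1 1 (-1) 0, Zmx 0 (-1) 1 (-2));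
  (Zmx 6 (-11) (-7) 13, Zmx 1 1 (-1) 0, Zmx 7 (-13) (-1) 2);
  (Zmx 6 (-11) (-1) 2, Zmx 1 0 0 1, Zmx 6 (-11) (-1) 2);
  (Zmx 6 (-7) (-11) 13, Zmx 1 1 (-2) (-1), Zmx 0 (-1) 1 (-1));
  (Zmx 6 (-5) (-25) 21, Zmx 1 0 (-4) 1, Zmx 6 (-5) (-1) 1);
  (Zmx 6 (-5) (-19) 16, Zmx 1 0 (-3) 1, Zmx 6 (-5) (-1) 1);
  (Zmx 6 (-5) (-13) 11, Zmx 1 1 (-2) (-1), Zmx 7 (-6) (-1) 1);
  (Zmx 6 (-1) (-11) 2, Zmx 1 1 (-2) (-1), Zmx 0 (-1) 1 0);
  (Zmx 6 1 (-25) (-4), Zmx 1 0 (-4) 1, Zmx 6 1 (-1) 0);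
  (Zmx 6 1 (-19) (-3), Zmx 1 0 (-3) 1, Zmx 6 1 (-1) 0);
  (Zmx 6 1 (-13) (-2), Zmx 1 1 (-2) (-1), Zmx 7 1 (-1) 0);
  (Zmx 6 5 (-11) (-9), Zmx 1 1 (-2) (-1), Zmx 0 (-1) 1 1);
  (Zmx 6 7 (-25) (-29), Zmx 1 0 (-4) 1, Zmx 6 7 (-1) (-1));
  (Zmx 6 7 (-19) (-22), Zmx 1 0 (-3) 1, Zmx 6 7 (-1) (-1));
  (Zmx 6 7 (-13) (-15), Zmx 1 1 (-2) (-1), Zmx 7 8 (-1) (-1));
  (Zmx 7 (-31) (-2) 9, Zmx 1 0 0 1, Zmx 7 (-31) (-2) 9);
  (Zmx 7 (-30) (-3) 13, Zmx 2 1 (-1) 0, Zmx (-2) 7 1 (-4));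
  (Zmx 7 (-29) (-6) 25, Zmx 1 1 (-1) 0, Zmx 1 (-5) 1 (-4));
  (Zmx 7 (-27) (-8) 31, Zmx 1 1 (-1) 0, Zmx 8 (-31) (-1) 4);
  (Zmx 7 (-27) (-1) 4, Zmx 1 0 0 1, Zmx 7 (-27) (-1) 4);
  (Zmx 7 (-26) (-4) 15, Zmx 2 1 (-1) 0, Zmx 4 (-15) (-1) 4);
  (Zmx 7 (-25) (-5) 18, Zmx 1 1 (-1) 0, Zmx (-5) 17 2 (-7));
  (Zmx 7 (-24) (-2) 7, Zmx 1 0 0 1, Zmx 7 (-24) (-2) 7);
  (Zmx 7 (-23) (-3) 10, Zmx 2 1 (-1) 0, Zmx (-2) 5 1 (-3));
  (Zmx 7 (-22) (-6) 19, Zmx 1 1 (-1) 0, Zmx 1 (-4) 1 (-3));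
  (Zmx 7 (-20) (-8) 23, Zmx 1 1 (-1) 0, Zmx 8 (-23) (-1) 3);
  (Zmx 7 (-20) (-1) 3, Zmx 1 0 0 1, Zmx 7 (-20) (-1) 3);
  (Zmx 7 (-19) (-4) 11, Zmx 2 1 (-1) 0, Zmx 4 (-11) (-1) 3);
  (Zmx 7 (-18) (-5) 13, Zmx 1 1 (-1) 0, Zmx (-5) 12 2 (-5));
  (Zmx 7 (-17) (-2) 5, Zmx 1 0 0 1, Zmx 7 (-17) (-2) 5);
  (Zmx 7 (-16) (-3) 7, Zmx 2 1 (-1) 0, Zmx (-2) 3 1 (-2));
  (Zmx 7 (-15) (-6) 13, Zmx 1 1 (-1) 0, Zmx 1 (-3) 1 (-2));
  (Zmx 7 (-13) (-8) 15, Zmx 1 1 (-1) 0, Zmx 8 (-15) (-1) 2);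
  (Zmx 7 (-13) (-1) 2, Zmx 1 0 0 1, Zmx 7 (-13) (-1) 2);
  (Zmx 7 (-12) (-4) 7, Zmx 2 1 (-1) 0, Zmx 4 (-7) (-1) 2);
  (Zmx 7 (-12) 3 (-5), Zmx 2 (-1) 1 0, Zmx 3 (-5) (-1) 2);
  (Zmx 7 (-12) 10 (-17), Zmx 2 (-1) 3 (-1), Zmx 3 (-5) (-1) 2);
  (Zmx 7 (-11) (-5) 8, Zmx 1 1 (-1) 0, Zmx (-5) 7 2 (-3));
  (Zmx 7 (-11) 2 (-3), Zmx 1 0 0 1, Zmx (-3) 4 2 (-3));
  (Zmx 7 (-10) (-9) 13, Zmx 3 1 (-4) (-1), Zmx (-3) 2 1 (-1));
  (Zmx 7 (-10) (-2) 3, Zmx 3 1 (-1) 0, Zmx (-3) 2 1 (-1));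
  (Zmx 7 (-10) 5 (-7), Zmx 1 (-1) 1 0, Zmx 5 (-7) (-2) 3);
  (Zmx 7 (-9) (-10) 13, Zmx 2 1 (-3) (-1), Zmx (-2) 1 1 (-1));
  (Zmx 7 (-9) (-3) 4, Zmx 2 1 (-1) 0, Zmx (-2) 1 1 (-1));
  (Zmx 7 (-9) 4 (-5), Zmx 2 (-1) 1 0, Zmx (-1) 0 1 (-1));
  (Zmx 7 (-8) (-13) 15, Zmx 1 1 (-2) (-1), Zmx 1 (-2) 1 (-1));
  (Zmx 7 (-6) (-29) 25, Zmx 1 0 (-4) 1, Zmx 7 (-6) (-1) 1);
  (Zmx 7 (-6) (-22) 19, Zmx 1 0 (-3) 1, Zmx 7 (-6) (-1) 1);
  (Zmx 7 (-6) (-15) 13, Zmx 1 1 (-2) (-1), Zmx 8 (-7) (-1) 1);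
  (Zmx 7 (-5) (-11) 8, Zmx 2 1 (-3) (-1), Zmx 4 (-3) (-1) 1);
  (Zmx 7 (-3) (-30) 13, Zmx 1 0 (-4) 1, Zmx 7 (-3) (-2) 1);
  (Zmx 7 (-3) (-23) 10, Zmx 1 0 (-3) 1, Zmx 7 (-3) (-2) 1);
  (Zmx 7 (-3) (-16) 7, Zmx 1 1 (-2) (-1), Zmx 9 (-4) (-2) 1);
  (Zmx 7 (-3) (-9) 4, Zmx 3 1 (-4) (-1), Zmx (-3) (-1) 1 0);
  (Zmx 7 (-2) (-31) 9, Zmx 2 1 (-9) (-4), Zmx (-2) (-1) 1 0);
  (Zmx 7 (-2) (-24) 7, Zmx 2 1 (-7) (-3), Zmx (-2) (-1) 1 0);
  (Zmx 7 (-2) (-17) 5, Zmx 2 1 (-5) (-2), Zmx (-2) (-1) 1 0);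
  (Zmx 7 (-2) (-10) 3, Zmx 2 1 (-3) (-1), Zmx (-2) (-1) 1 0);
  (Zmx 7 (-1) (-13) 2, Zmx 1 1 (-2) (-1), Zmx 1 (-1) 1 0);
  (Zmx 7 1 (-29) (-4), Zmx 1 0 (-4) 1, Zmx 7 1 (-1) 0);
  (Zmx 7 1 (-22) (-3), Zmx 1 0 (-3) 1, Zmx 7 1 (-1) 0);
  (Zmx 7 1 (-15) (-2), Zmx 1 1 (-2) (-1), Zmx 8 1 (-1) 0);
  (Zmx 7 2 (-25) (-7), Zmx 2 1 (-7) (-3), Zmx 4 1 (-1) 0);
  (Zmx 7 2 (-18) (-5), Zmx 2 1 (-5) (-2), Zmx 4 1 (-1) 0);
  (Zmx 7 2 (-11) (-3), Zmx 2 1 (-3) (-1), Zmx 4 1 (-1) 0);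
  (Zmx 7 2 10 3, Zmx 0 (-1) 1 0, Zmx 10 3 (-7) (-2));
  (Zmx 7 2 17 5, Zmx 0 (-1) 1 0, Zmx 17 5 (-7) (-2));
  (Zmx 7 4 (-30) (-17), Zmx 1 0 (-4) 1, Zmx 7 4 (-2) (-1));
  (Zmx 7 4 (-23) (-13), Zmx 1 0 (-3) 1, Zmx 7 4 (-2) (-1));
  (Zmx 7 4 (-16) (-9), Zmx 1 1 (-2) (-1), Zmx 9 5 (-2) (-1));
  (Zmx 7 4 (-9) (-5), Zmx 1 1 (-1) 0, Zmx 9 5 (-2) (-1));
  (Zmx 7 4 12 7, Zmx 0 (-1) 1 0, Zmx 12 7 (-7) (-4));
  (Zmx 7 5 (-31) (-22), Zmx 2 1 (-9) (-4), Zmx (-2) (-3) 1 1);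
  (Zmx 7 5 (-24) (-17), Zmx 2 1 (-7) (-3), Zmx (-2) (-3) 1 1);
  (Zmx 7 5 (-17) (-12), Zmx 2 1 (-5) (-2), Zmx (-2) (-3) 1 1);
  (Zmx 7 5 (-10) (-7), Zmx 2 1 (-3) (-1), Zmx (-2) (-3) 1 1);
  (Zmx 7 6 (-13) (-11), Zmx 1 1 (-2) (-1), Zmx 1 0 1 1);
  (Zmx 7 8 (-29) (-33), Zmx 1 0 (-4) 1, Zmx 7 8 (-1) (-1));
  (Zmx 7 8 (-22) (-25), Zmx 1 0 (-3) 1, Zmx 7 8 (-1) (-1));
  (Zmx 7 8 (-15) (-17), Zmx 1 1 (-2) (-1), Zmx 8 9 (-1) (-1));
  (Zmx 7 9 (-11) (-14), Zmx 2 1 (-3) (-1), Zmx 4 5 (-1) (-1));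
  (Zmx 7 9 (-4) (-5), Zmx 7 2 (-4) (-1), Zmx 1 (-4) 0 1);
  (Zmx 7 9 3 4, Zmx 1 0 0 1, Zmx (-8) (-11) 3 4);
  (Zmx 7 10 (-5) (-7), Zmx 7 3 (-5) (-2), Zmx 1 (-4) 0 1);
  (Zmx 7 10 2 3, Zmx 1 0 0 1, Zmx (-3) (-5) 2 3);
  (Zmx 7 11 (-2) (-3), Zmx 7 4 (-2) (-1), Zmx 1 (-4) 0 1);
  (Zmx 7 11 5 8, Zmx 1 (-1) 1 0, Zmx 5 8 (-2) (-3));
  (Zmx 7 12 (-3) (-5), Zmx 7 (-2) (-3) 1, Zmx 1 (-3) 0 1);
  (Zmx 7 12 4 7, Zmx 2 (-1) 1 0, Zmx (-1) (-3) 1 2);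
  (Zmx 7 17 (-5) (-12), Zmx 7 3 (-5) (-2), Zmx 1 (-3) 0 1);
  (Zmx 7 19 (-3) (-8), Zmx 7 (-2) (-3) 1, Zmx 1 (-2) 0 1);
  (Zmx 8 (-33) (-7) 29, Zmx 1 1 (-1) 0, Zmx 2 (-9) 1 (-4));
  (Zmx 8 (-31) (-9) 35, Zmx 1 1 (-1) 0, Zmx 9 (-35) (-1) 4);
  (Zmx 8 (-31) (-1) 4, Zmx 1 0 0 1, Zmx 8 (-31) (-1) 4);
  (Zmx 8 (-25) (-7) 22, Zmx 1 1 (-1) 0, Zmx 2 (-7) 1 (-3));
  (Zmx 8 (-23) (-9) 26, Zmx 1 1 (-1) 0, Zmx 9 (-26) (-1) 3);
  (Zmx 8 (-23) (-1) 3, Zmx 1 0 0 1, Zmx 8 (-23) (-1) 3);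
  (Zmx 8 (-19) (-5) 12, Zmx 3 2 (-2) (-1), Zmx (-3) 5 1 (-2));
  (Zmx 8 (-17) (-7) 15, Zmx 1 1 (-1) 0, Zmx 2 (-5) 1 (-2));
  (Zmx 8 (-15) (-9) 17, Zmx 1 1 (-1) 0, Zmx 9 (-17) (-1) 2);
  (Zmx 8 (-15) (-1) 2, Zmx 1 0 0 1, Zmx 8 (-15) (-1) 2);
  (Zmx 8 (-13) (-3) 5, Zmx 1 0 0 1, Zmx 8 (-13) (-3) 5);
  (Zmx 8 (-11) (-5) 7, Zmx 3 2 (-2) (-1), Zmx (-3) 2 1 (-1));
  (Zmx 8 (-11) 3 (-4), Zmx 1 0 0 1, Zmx (-7) 9 3 (-4));
  (Zmx 8 (-9) (-15) 17, Zmx 1 1 (-2) (-1), Zmx 2 (-3) 1 (-1));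
  (Zmx 8 (-9) (-7) 8, Zmx 1 1 (-1) 0, Zmx 2 (-3) 1 (-1));
  (Zmx 8 (-9) 1 (-1), Zmx 1 0 0 1, Zmx 3 (-4) 1 (-1));
  (Zmx 8 (-7) (-33) 29, Zmx 1 0 (-4) 1, Zmx 8 (-7) (-1) 1);
  (Zmx 8 (-7) (-25) 22, Zmx 1 0 (-3) 1, Zmx 8 (-7) (-1) 1);
  (Zmx 8 (-7) (-17) 15, Zmx 1 1 (-2) (-1), Zmx 9 (-8) (-1) 1);
  (Zmx 8 (-7) (-9) 8, Zmx 1 1 (-1) 0, Zmx 9 (-8) (-1) 1);
  (Zmx 8 (-5) (-11) 7, Zmx 1 1 (-1) 0, Zmx 11 (-7) (-3) 2);
  (Zmx 8 (-1) (-15) 2, Zmx 1 1 (-2) (-1), Zmx 2 (-1) 1 0);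
  (Zmx 8 1 (-33) (-4), Zmx 1 0 (-4) 1, Zmx 8 1 (-1) 0);
  (Zmx 8 1 (-25) (-3), Zmx 1 0 (-3) 1, Zmx 8 1 (-1) 0);
  (Zmx 8 1 (-17) (-2), Zmx 1 1 (-2) (-1), Zmx 9 1 (-1) 0);
  (Zmx 8 1 (-9) (-1), Zmx 1 1 (-1) 0, Zmx 9 1 (-1) 0);
  (Zmx 8 3 (-11) (-4), Zmx 3 1 (-4) (-1), Zmx 3 1 (-1) 0);
  (Zmx 8 3 13 5, Zmx 3 1 5 2, Zmx 3 1 (-1) 0);
  (Zmx 8 5 11 7, Zmx 1 (-1) 1 0, Zmx (-4) (-3) 3 2);
  (Zmx 8 7 (-15) (-13), Zmx 1 1 (-2) (-1), Zmx 2 1 1 1);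
  (Zmx 8 9 (-33) (-37), Zmx 1 0 (-4) 1, Zmx 8 9 (-1) (-1));
  (Zmx 8 9 (-25) (-28), Zmx 1 0 (-3) 1, Zmx 8 9 (-1) (-1));
  (Zmx 8 9 (-17) (-19), Zmx 1 1 (-2) (-1), Zmx 9 10 (-1) (-1));
  (Zmx 8 9 (-9) (-10), Zmx 8 1 (-9) (-1), Zmx 1 (-4) 0 1);
  (Zmx 8 9 (-1) (-1), Zmx 8 1 (-1) 0, Zmx 1 (-4) 0 1);
  (Zmx 8 9 7 8, Zmx 0 (-1) 1 0, Zmx 7 8 (-8) (-9));
  (Zmx 8 11 (-11) (-15), Zmx 3 1 (-4) (-1), Zmx 3 4 (-1) (-1));
  (Zmx 8 11 (-3) (-4), Zmx 3 1 (-1) 0, Zmx 3 4 (-1) (-1));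
  (Zmx 8 11 5 7, Zmx 3 1 2 1, Zmx 3 4 (-1) (-1));
  (Zmx 8 13 3 5, Zmx 1 0 0 1, Zmx (-7) (-12) 3 5);
  (Zmx 9 (-40) (-2) 9, Zmx 1 0 0 1, Zmx 9 (-40) (-2) 9);
  (Zmx 9 (-38) (-4) 17, Zmx 2 1 (-1) 0, Zmx (-1) 3 1 (-4));
  (Zmx 9 (-37) (-8) 33, Zmx 1 1 (-1) 0, Zmx 3 (-13) 1 (-4));
  (Zmx 9 (-34) (-5) 19, Zmx 2 1 (-1) 0, Zmx 5 (-19) (-1) 4);
  (Zmx 9 (-31) (-2) 7, Zmx 1 0 0 1, Zmx 9 (-31) (-2) 7);
  (Zmx 9 (-29) (-4) 13, Zmx 2 1 (-1) 0, Zmx (-1) 2 1 (-3));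
  (Zmx 9 (-28) (-8) 25, Zmx 1 1 (-1) 0, Zmx 3 (-10) 1 (-3));
  (Zmx 9 (-25) (-5) 14, Zmx 2 1 (-1) 0, Zmx 5 (-14) (-1) 3);
  (Zmx 9 (-22) (-2) 5, Zmx 1 0 0 1, Zmx 9 (-22) (-2) 5);
  (Zmx 9 (-20) (-4) 9, Zmx 2 1 (-1) 0, Zmx (-1) 1 1 (-2));
  (Zmx 9 (-19) (-8) 17, Zmx 1 1 (-1) 0, Zmx 3 (-7) 1 (-2));
  (Zmx 9 (-16) (-5) 9, Zmx 2 1 (-1) 0, Zmx 5 (-9) (-1) 2);
  (Zmx 9 (-13) (-2) 3, Zmx 4 1 (-1) 0, Zmx (-3) 2 1 (-1));
  (Zmx 9 (-11) (-13) 16, Zmx 2 1 (-3) (-1), Zmx (-1) 0 1 (-1));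
  (Zmx 9 (-11) (-4) 5, Zmx 2 1 (-1) 0, Zmx (-1) 0 1 (-1));
  (Zmx 9 (-11) 5 (-6), Zmx 2 (-1) 1 0, Zmx 0 (-1) 1 (-1));
  (Zmx 9 (-10) (-8) 9, Zmx 1 1 (-1) 0, Zmx 3 (-4) 1 (-1));
  (Zmx 9 (-8) (-37) 33, Zmx 1 0 (-4) 1, Zmx 9 (-8) (-1) 1);
  (Zmx 9 (-8) (-28) 25, Zmx 1 0 (-3) 1, Zmx 9 (-8) (-1) 1);
  (Zmx 9 (-8) (-19) 17, Zmx 1 1 (-2) (-1), Zmx 10 (-9) (-1) 1);
  (Zmx 9 (-8) (-10) 9, Zmx 1 1 (-1) 0, Zmx 10 (-9) (-1) 1);
  (Zmx 9 (-8) (-1) 1, Zmx 1 0 0 1, Zmx 9 (-8) (-1) 1);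
  (Zmx 9 (-8) 8 (-7), Zmx 0 (-1) 1 0, Zmx 8 (-7) (-9) 8);
  (Zmx 9 (-7) (-14) 11, Zmx 2 1 (-3) (-1), Zmx 5 (-4) (-1) 1);
  (Zmx 9 (-7) (-5) 4, Zmx 2 1 (-1) 0, Zmx 5 (-4) (-1) 1);
  (Zmx 9 (-7) 4 (-3), Zmx 1 0 0 1, Zmx (-11) 8 4 (-3));
  (Zmx 9 (-5) (-7) 4, Zmx 1 1 (-1) 0, Zmx (-3) 1 2 (-1));
  (Zmx 9 (-5) 2 (-1), Zmx 1 0 0 1, Zmx (-1) 0 2 (-1));
  (Zmx 9 (-4) (-38) 17, Zmx 1 0 (-4) 1, Zmx 9 (-4) (-2) 1);
  (Zmx 9 (-4) (-29) 13, Zmx 1 0 (-3) 1, Zmx 9 (-4) (-2) 1);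
  (Zmx 9 (-4) (-20) 9, Zmx 1 1 (-2) (-1), Zmx 11 (-5) (-2) 1);
  (Zmx 9 (-4) (-11) 5, Zmx 1 1 (-1) 0, Zmx 11 (-5) (-2) 1);
  (Zmx 9 (-4) (-2) 1, Zmx 4 1 (-1) 0, Zmx (-3) (-1) 1 0);
  (Zmx 9 (-4) 7 (-3), Zmx 0 (-1) 1 0, Zmx 7 (-3) (-9) 4);
  (Zmx 9 (-2) (-40) 9, Zmx 2 1 (-9) (-4), Zmx (-1) (-1) 1 0);
  (Zmx 9 (-2) (-31) 7, Zmx 2 1 (-7) (-3), Zmx (-1) (-1) 1 0);
  (Zmx 9 (-2) (-22) 5, Zmx 2 1 (-5) (-2), Zmx (-1) (-1) 1 0);
  (Zmx 9 (-2) (-13) 3, Zmx 2 1 (-3) (-1), Zmx (-1) (-1) 1 0);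
  (Zmx 9 (-2) (-4) 1, Zmx 2 1 (-1) 0, Zmx (-1) (-1) 1 0);
  (Zmx 9 (-2) 5 (-1), Zmx 0 (-1) 1 0, Zmx 5 (-1) (-9) 2);
  (Zmx 9 (-1) (-17) 2, Zmx 1 1 (-2) (-1), Zmx 3 (-1) 1 0);
  (Zmx 9 (-1) (-8) 1, Zmx 1 1 (-1) 0, Zmx 3 (-1) 1 0);
  (Zmx 9 (-1) 1 0, Zmx 1 0 0 1, Zmx 4 (-1) 1 0);
  (Zmx 9 1 (-37) (-4), Zmx 1 0 (-4) 1, Zmx 9 1 (-1) 0);
  (Zmx 9 1 (-28) (-3), Zmx 1 0 (-3) 1, Zmx 9 1 (-1) 0);
  (Zmx 9 1 (-19) (-2), Zmx 1 1 (-2) (-1), Zmx 10 1 (-1) 0);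
  (Zmx 9 1 (-10) (-1), Zmx 1 1 (-1) 0, Zmx 10 1 (-1) 0);
  (Zmx 9 1 (-1) 0, Zmx 1 0 0 1, Zmx 9 1 (-1) 0);
  (Zmx 9 1 8 1, Zmx 0 (-1) 1 0, Zmx 8 1 (-9) (-1));
  (Zmx 9 2 (-14) (-3), Zmx 2 1 (-3) (-1), Zmx 5 1 (-1) 0);
  (Zmx 9 2 (-5) (-1), Zmx 2 1 (-1) 0, Zmx 5 1 (-1) 0);
  (Zmx 9 2 4 1, Zmx 1 0 0 1, Zmx (-11) (-3) 4 1);
  (Zmx 9 4 (-7) (-3), Zmx 4 (-1) (-3) 1, Zmx 2 1 (-1) 0);
  (Zmx 9 4 2 1, Zmx 1 0 0 1, Zmx (-1) (-1) 2 1);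
  (Zmx 9 5 (-38) (-21), Zmx 1 0 (-4) 1, Zmx 9 5 (-2) (-1));
  (Zmx 9 5 (-29) (-16), Zmx 1 0 (-3) 1, Zmx 9 5 (-2) (-1));
  (Zmx 9 5 (-20) (-11), Zmx 1 1 (-2) (-1), Zmx 11 6 (-2) (-1));
  (Zmx 9 5 (-11) (-6), Zmx 1 1 (-1) 0, Zmx 11 6 (-2) (-1));
  (Zmx 9 5 (-2) (-1), Zmx 9 5 (-2) (-1), Zmx 1 (-5) 0 1);
  (Zmx 9 5 7 4, Zmx 0 (-1) 1 0, Zmx 7 4 (-9) (-5));
  (Zmx 9 7 (-40) (-31), Zmx 2 1 (-9) (-4), Zmx (-1) (-2) 1 1);
  (Zmx 9 7 (-31) (-24), Zmx 2 1 (-7) (-3), Zmx (-1) (-2) 1 1);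
  (Zmx 9 7 (-22) (-17), Zmx 2 1 (-5) (-2), Zmx (-1) (-2) 1 1);
  (Zmx 9 7 (-13) (-10), Zmx 2 1 (-3) (-1), Zmx (-1) (-2) 1 1);
  (Zmx 9 7 (-4) (-3), Zmx 9 (-2) (-4) 1, Zmx 1 (-4) 0 1);
  (Zmx 9 7 5 4, Zmx 0 (-1) 1 0, Zmx 5 4 (-9) (-7));
  (Zmx 9 8 (-17) (-15), Zmx 1 1 (-2) (-1), Zmx 3 2 1 1);
  (Zmx 9 8 (-8) (-7), Zmx 9 (-1) (-8) 1, Zmx 1 (-4) 0 1);
  (Zmx 9 8 1 1, Zmx 1 0 0 1, Zmx 4 3 1 1);
  (Zmx 9 11 (-14) (-17), Zmx 2 1 (-3) (-1), Zmx 5 6 (-1) (-1));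
  (Zmx 9 11 (-5) (-6), Zmx 9 2 (-5) (-1), Zmx 1 (-4) 0 1);
  (Zmx 9 11 4 5, Zmx 2 (-1) 1 0, Zmx 4 5 (-1) (-1));
  (Zmx 10 (-33) (-3) 10, Zmx 3 1 (-1) 0, Zmx (-2) 5 1 (-3));
  (Zmx 10 (-23) (-3) 7, Zmx 3 1 (-1) 0, Zmx (-2) 3 1 (-2));
  (Zmx 10 (-13) (-13) 17, Zmx 3 1 (-4) (-1), Zmx (-2) 1 1 (-1));
  (Zmx 10 (-13) (-3) 4, Zmx 3 1 (-1) 0, Zmx (-2) 1 1 (-1));
  (Zmx 10 (-7) (-7) 5, Zmx 3 2 (-2) (-1), Zmx 4 (-3) (-1) 1);
  (Zmx 10 (-7) 3 (-2), Zmx 1 0 0 1, Zmx (-5) 3 3 (-2));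
  (Zmx 10 (-3) (-13) 4, Zmx 3 1 (-4) (-1), Zmx (-2) (-1) 1 0);
  (Zmx 10 (-3) (-3) 1, Zmx 3 1 (-1) 0, Zmx (-2) (-1) 1 0);
  (Zmx 10 (-3) 7 (-2), Zmx 1 (-1) 1 0, Zmx 7 (-2) (-3) 1);
  (Zmx 10 3 (-7) (-2), Zmx 3 2 (-2) (-1), Zmx 4 1 (-1) 0);
  (Zmx 10 3 3 1, Zmx 1 0 0 1, Zmx (-5) (-2) 3 1);
  (Zmx 10 7 (-13) (-9), Zmx 3 1 (-4) (-1), Zmx (-2) (-3) 1 1);
  (Zmx 10 7 (-3) (-2), Zmx 3 1 (-1) 0, Zmx (-2) (-3) 1 1);
  (Zmx 10 7 7 5, Zmx 1 (-1) 1 0, Zmx 7 5 (-3) (-2));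
  (Zmx 10 17 (-3) (-5), Zmx 10 (-3) (-3) 1, Zmx 1 (-3) 0 1);
  (Zmx 10 27 (-3) (-8), Zmx 10 (-3) (-3) 1, Zmx 1 (-2) 0 1);
  (Zmx 11 (-13) (-16) 19, Zmx 2 1 (-3) (-1), Zmx 0 (-1) 1 (-1));
  (Zmx 11 (-13) (-5) 6, Zmx 2 1 (-1) 0, Zmx 0 (-1) 1 (-1));
  (Zmx 11 (-13) 6 (-7), Zmx 2 (-1) 1 0, Zmx 1 (-2) 1 (-1));
  (Zmx 11 (-9) (-17) 14, Zmx 2 1 (-3) (-1), Zmx 6 (-5) (-1) 1);
  (Zmx 11 (-9) (-6) 5, Zmx 2 1 (-1) 0, Zmx 6 (-5) (-1) 1);
  (Zmx 11 (-9) 5 (-4), Zmx 2 (-1) 1 0, Zmx 5 (-4) (-1) 1);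
  (Zmx 11 (-8) (-15) 11, Zmx 3 1 (-4) (-1), Zmx 4 (-3) (-1) 1);
  (Zmx 11 (-8) (-4) 3, Zmx 3 1 (-1) 0, Zmx 4 (-3) (-1) 1);
  (Zmx 11 (-8) 7 (-5), Zmx 3 1 2 1, Zmx 4 (-3) (-1) 1);
  (Zmx 11 (-7) (-3) 2, Zmx 1 0 0 1, Zmx 11 (-7) (-3) 2);
  (Zmx 11 (-7) 8 (-5), Zmx 1 (-1) 1 0, Zmx 8 (-5) (-3) 2);
  (Zmx 11 (-4) (-8) 3, Zmx 4 (-1) (-3) 1, Zmx (-2) (-1) 1 0);
  (Zmx 11 (-4) 3 (-1), Zmx 1 0 0 1, Zmx (-4) 1 3 (-1));
  (Zmx 11 (-3) (-7) 2, Zmx 3 2 (-2) (-1), Zmx (-2) (-1) 1 0);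
  (Zmx 11 (-3) 4 (-1), Zmx 1 0 0 1, Zmx (-9) 2 4 (-1));
  (Zmx 11 (-2) (-16) 3, Zmx 2 1 (-3) (-1), Zmx 0 (-1) 1 0);
  (Zmx 11 (-2) (-5) 1, Zmx 2 1 (-1) 0, Zmx 0 (-1) 1 0);
  (Zmx 11 (-2) 6 (-1), Zmx 2 (-1) 1 0, Zmx 1 (-1) 1 0);
  (Zmx 11 2 (-17) (-3), Zmx 2 1 (-3) (-1), Zmx 6 1 (-1) 0);
  (Zmx 11 2 (-6) (-1), Zmx 2 1 (-1) 0, Zmx 6 1 (-1) 0);
  (Zmx 11 2 5 1, Zmx 2 (-1) 1 0, Zmx 5 1 (-1) 0);
  (Zmx 11 3 (-15) (-4), Zmx 3 1 (-4) (-1), Zmx 4 1 (-1) 0);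
  (Zmx 11 3 (-4) (-1), Zmx 3 1 (-1) 0, Zmx 4 1 (-1) 0);
  (Zmx 11 3 7 2, Zmx 3 1 2 1, Zmx 4 1 (-1) 0);
  (Zmx 11 4 (-3) (-1), Zmx 4 1 (-1) 0, Zmx 3 1 (-1) 0);
  (Zmx 11 4 8 3, Zmx 1 (-1) 1 0, Zmx 8 3 (-3) (-1));
  (Zmx 11 7 (-8) (-5), Zmx 1 1 (-1) 0, Zmx (-7) (-5) 3 2);
  (Zmx 11 7 3 2, Zmx 1 0 0 1, Zmx (-4) (-3) 3 2);
  (Zmx 11 8 (-7) (-5), Zmx 3 2 (-2) (-1), Zmx (-2) (-3) 1 1);
  (Zmx 11 8 4 3, Zmx 1 0 0 1, Zmx (-9) (-7) 4 3);
  (Zmx 11 9 (-16) (-13), Zmx 2 1 (-3) (-1), Zmx 0 (-1) 1 1);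
  (Zmx 11 9 (-5) (-4), Zmx 2 1 (-1) 0, Zmx 0 (-1) 1 1);
  (Zmx 11 9 6 5, Zmx 2 (-1) 1 0, Zmx 1 0 1 1);
  (Zmx 11 13 (-17) (-20), Zmx 2 1 (-3) (-1), Zmx 6 7 (-1) (-1));
  (Zmx 11 13 (-6) (-7), Zmx 2 1 (-1) 0, Zmx 6 7 (-1) (-1));
  (Zmx 11 13 5 6, Zmx 2 (-1) 1 0, Zmx 5 6 (-1) (-1));
  (Zmx 11 14 (-15) (-19), Zmx 3 1 (-4) (-1), Zmx 4 5 (-1) (-1));
  (Zmx 11 14 (-4) (-5), Zmx 3 1 (-1) 0, Zmx 4 5 (-1) (-1));
  (Zmx 12 (-7) (-5) 3, Zmx 2 1 (-1) 0, Zmx (-5) 2 2 (-1));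
  (Zmx 12 (-7) 7 (-4), Zmx 2 (-1) 1 0, Zmx (-3) 1 2 (-1));
  (Zmx 12 (-5) (-7) 3, Zmx 2 1 (-1) 0, Zmx 7 (-3) (-2) 1);
  (Zmx 12 (-5) 5 (-2), Zmx 2 (-1) 1 0, Zmx 5 (-2) (-2) 1);
  (Zmx 12 5 (-5) (-2), Zmx 2 1 (-1) 0, Zmx (-5) (-3) 2 1);
  (Zmx 12 5 7 3, Zmx 2 (-1) 1 0, Zmx (-3) (-2) 2 1);
  (Zmx 12 7 (-7) (-4), Zmx 2 1 (-1) 0, Zmx 7 4 (-2) (-1));
  (Zmx 12 7 5 3, Zmx 2 (-1) 1 0, Zmx 5 3 (-2) (-1));
  (Zmx 13 (-16) (-17) 21, Zmx 3 1 (-4) (-1), Zmx (-1) 0 1 (-1));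
  (Zmx 13 (-16) (-4) 5, Zmx 3 1 (-1) 0, Zmx (-1) 0 1 (-1));
  (Zmx 13 (-15) (-19) 22, Zmx 2 1 (-3) (-1), Zmx 1 (-2) 1 (-1));
  (Zmx 13 (-15) (-6) 7, Zmx 2 1 (-1) 0, Zmx 1 (-2) 1 (-1));
  (Zmx 13 (-15) 7 (-8), Zmx 2 (-1) 1 0, Zmx 2 (-3) 1 (-1));
  (Zmx 13 (-11) (-20) 17, Zmx 2 1 (-3) (-1), Zmx 7 (-6) (-1) 1);
  (Zmx 13 (-11) (-7) 6, Zmx 2 1 (-1) 0, Zmx 7 (-6) (-1) 1);
  (Zmx 13 (-11) 6 (-5), Zmx 2 (-1) 1 0, Zmx 6 (-5) (-1) 1);
  (Zmx 13 (-8) 5 (-3), Zmx 1 0 0 1, Zmx (-12) 7 5 (-3));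
  (Zmx 13 (-5) (-5) 2, Zmx 5 3 (-2) (-1), Zmx (-3) (-1) 1 0);
  (Zmx 13 (-5) 8 (-3), Zmx 5 (-2) 3 (-1), Zmx (-2) (-1) 1 0);
  (Zmx 13 (-3) (-17) 4, Zmx 3 1 (-4) (-1), Zmx (-1) (-1) 1 0);
  (Zmx 13 (-3) (-4) 1, Zmx 3 1 (-1) 0, Zmx (-1) (-1) 1 0);
  (Zmx 13 (-2) (-19) 3, Zmx 2 1 (-3) (-1), Zmx 1 (-1) 1 0);
  (Zmx 13 (-2) (-6) 1, Zmx 2 1 (-1) 0, Zmx 1 (-1) 1 0);
  (Zmx 13 (-2) 7 (-1), Zmx 2 (-1) 1 0, Zmx 2 (-1) 1 0);
  (Zmx 13 2 (-20) (-3), Zmx 2 1 (-3) (-1), Zmx 7 1 (-1) 0);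
  (Zmx 13 2 (-7) (-1), Zmx 2 1 (-1) 0, Zmx 7 1 (-1) 0);
  (Zmx 13 2 6 1, Zmx 2 (-1) 1 0, Zmx 6 1 (-1) 0);
  (Zmx 13 5 (-8) (-3), Zmx 5 2 (-3) (-1), Zmx 3 1 (-1) 0);
  (Zmx 13 5 5 2, Zmx 1 0 0 1, Zmx (-12) (-5) 5 2);
  (Zmx 13 8 (-5) (-3), Zmx 1 0 0 1, Zmx 13 8 (-5) (-3));
  (Zmx 13 10 (-17) (-13), Zmx 3 1 (-4) (-1), Zmx (-1) (-2) 1 1);
  (Zmx 13 10 (-4) (-3), Zmx 3 1 (-1) 0, Zmx (-1) (-2) 1 1);
  (Zmx 13 11 (-19) (-16), Zmx 2 1 (-3) (-1), Zmx 1 0 1 1);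
  (Zmx 13 11 (-6) (-5), Zmx 2 1 (-1) 0, Zmx 1 0 1 1);
  (Zmx 13 11 7 6, Zmx 2 (-1) 1 0, Zmx 2 1 1 1);
  (Zmx 13 15 (-7) (-8), Zmx 2 1 (-1) 0, Zmx 7 8 (-1) (-1));
  (Zmx 13 15 6 7, Zmx 2 (-1) 1 0, Zmx 6 7 (-1) (-1));
  (Zmx 14 (-11) (-19) 15, Zmx 3 1 (-4) (-1), Zmx 5 (-4) (-1) 1);
  (Zmx 14 (-11) (-5) 4, Zmx 3 1 (-1) 0, Zmx 5 (-4) (-1) 1);
  (Zmx 14 3 (-19) (-4), Zmx 3 1 (-4) (-1), Zmx 5 1 (-1) 0);
  (Zmx 14 3 (-5) (-1), Zmx 3 1 (-1) 0, Zmx 5 1 (-1) 0);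
  (Zmx 14 17 (-19) (-23), Zmx 3 1 (-4) (-1), Zmx 5 6 (-1) (-1));
  (Zmx 14 17 (-5) (-6), Zmx 3 1 (-1) 0, Zmx 5 6 (-1) (-1));
  (Zmx 15 (-17) (-22) 25, Zmx 2 1 (-3) (-1), Zmx 2 (-3) 1 (-1));
  (Zmx 15 (-17) (-7) 8, Zmx 2 1 (-1) 0, Zmx 2 (-3) 1 (-1));
  (Zmx 15 (-13) (-8) 7, Zmx 2 1 (-1) 0, Zmx 8 (-7) (-1) 1);
  (Zmx 15 (-13) 7 (-6), Zmx 2 (-1) 1 0, Zmx 7 (-6) (-1) 1);
  (Zmx 15 (-2) (-22) 3, Zmx 2 1 (-3) (-1), Zmx 2 (-1) 1 0);
  (Zmx 15 (-2) (-7) 1, Zmx 2 1 (-1) 0, Zmx 2 (-1) 1 0);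
  (Zmx 15 (-2) 8 (-1), Zmx 2 (-1) 1 0, Zmx 3 (-1) 1 0);
  (Zmx 15 2 (-8) (-1), Zmx 2 1 (-1) 0, Zmx 8 1 (-1) 0);
  (Zmx 15 2 7 1, Zmx 2 (-1) 1 0, Zmx 7 1 (-1) 0);
  (Zmx 15 13 (-22) (-19), Zmx 2 1 (-3) (-1), Zmx 2 1 1 1);
  (Zmx 15 13 (-7) (-6), Zmx 2 1 (-1) 0, Zmx 2 1 1 1);
  (Zmx 15 13 8 7, Zmx 2 (-1) 1 0, Zmx 3 2 1 1);
  (Zmx 16 (-19) (-21) 25, Zmx 3 1 (-4) (-1), Zmx 0 (-1) 1 (-1));
  (Zmx 16 (-19) (-5) 6, Zmx 3 1 (-1) 0, Zmx 0 (-1) 1 (-1));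
  (Zmx 16 (-9) (-7) 4, Zmx 2 1 (-1) 0, Zmx (-3) 1 2 (-1));
  (Zmx 16 (-3) (-21) 4, Zmx 3 1 (-4) (-1), Zmx 0 (-1) 1 0);
  (Zmx 16 (-3) (-5) 1, Zmx 3 1 (-1) 0, Zmx 0 (-1) 1 0);
  (Zmx 16 9 (-9) (-5), Zmx 2 1 (-1) 0, Zmx 9 5 (-2) (-1));
  (Zmx 16 13 (-21) (-17), Zmx 3 1 (-4) (-1), Zmx 0 (-1) 1 1);
  (Zmx 16 13 (-5) (-4), Zmx 3 1 (-1) 0, Zmx 0 (-1) 1 1);
  (Zmx 17 (-14) (-23) 19, Zmx 3 1 (-4) (-1), Zmx 6 (-5) (-1) 1);
  (Zmx 17 (-14) (-6) 5, Zmx 3 1 (-1) 0, Zmx 6 (-5) (-1) 1);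
  (Zmx 17 (-5) 7 (-2), Zmx 5 2 2 1, Zmx (-2) (-1) 1 0);
  (Zmx 17 (-2) (-25) 3, Zmx 2 1 (-3) (-1), Zmx 3 (-1) 1 0);
  (Zmx 17 (-2) (-8) 1, Zmx 2 1 (-1) 0, Zmx 3 (-1) 1 0);
  (Zmx 17 3 (-23) (-4), Zmx 3 1 (-4) (-1), Zmx 6 1 (-1) 0);
  (Zmx 17 3 (-6) (-1), Zmx 3 1 (-1) 0, Zmx 6 1 (-1) 0);
  (Zmx 17 7 (-5) (-2), Zmx 1 0 0 1, Zmx 17 7 (-5) (-2));
  (Zmx 17 15 (-25) (-22), Zmx 2 1 (-3) (-1), Zmx 3 2 1 1);
  (Zmx 17 15 (-8) (-7), Zmx 2 1 (-1) 0, Zmx 3 2 1 1);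
  (Zmx 17 20 (-23) (-27), Zmx 3 1 (-4) (-1), Zmx 6 7 (-1) (-1));
  (Zmx 17 20 (-6) (-7), Zmx 3 1 (-1) 0, Zmx 6 7 (-1) (-1));
  (Zmx 18 (-5) (-7) 2, Zmx 5 3 (-2) (-1), Zmx (-2) (-1) 1 0);
  (Zmx 18 5 (-11) (-3), Zmx 5 2 (-3) (-1), Zmx 4 1 (-1) 0);
  (Zmx 19 (-22) (-25) 29, Zmx 3 1 (-4) (-1), Zmx 1 (-2) 1 (-1));
  (Zmx 19 (-22) (-6) 7, Zmx 3 1 (-1) 0, Zmx 1 (-2) 1 (-1));
  (Zmx 19 (-7) (-8) 3, Zmx 2 1 (-1) 0, Zmx (-7) 2 3 (-1));
  (Zmx 19 (-3) (-25) 4, Zmx 3 1 (-4) (-1), Zmx 1 (-1) 1 0);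
  (Zmx 19 (-3) (-6) 1, Zmx 3 1 (-1) 0, Zmx 1 (-1) 1 0);
  (Zmx 19 7 (-11) (-4), Zmx 2 1 (-1) 0, Zmx 11 4 (-3) (-1));
  (Zmx 19 16 (-25) (-21), Zmx 3 1 (-4) (-1), Zmx 1 0 1 1);
  (Zmx 19 16 (-6) (-5), Zmx 3 1 (-1) 0, Zmx 1 0 1 1);
  (Zmx 20 (-17) (-27) 23, Zmx 3 1 (-4) (-1), Zmx 7 (-6) (-1) 1);
  (Zmx 20 (-17) (-7) 6, Zmx 3 1 (-1) 0, Zmx 7 (-6) (-1) 1);
  (Zmx 20 3 (-27) (-4), Zmx 3 1 (-4) (-1), Zmx 7 1 (-1) 0);
  (Zmx 20 3 (-7) (-1), Zmx 3 1 (-1) 0, Zmx 7 1 (-1) 0);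
  (Zmx 22 (-25) (-29) 33, Zmx 3 1 (-4) (-1), Zmx 2 (-3) 1 (-1));
  (Zmx 22 (-25) (-7) 8, Zmx 3 1 (-1) 0, Zmx 2 (-3) 1 (-1));
  (Zmx 22 (-3) (-29) 4, Zmx 3 1 (-4) (-1), Zmx 2 (-1) 1 0);
  (Zmx 22 (-3) (-7) 1, Zmx 3 1 (-1) 0, Zmx 2 (-1) 1 0);
  (Zmx 22 19 (-29) (-25), Zmx 3 1 (-4) (-1), Zmx 2 1 1 1);
  (Zmx 22 19 (-7) (-6), Zmx 3 1 (-1) 0, Zmx 2 1 1 1);
  (Zmx 25 (-9) (-11) 4, Zmx 2 1 (-1) 0, Zmx (-4) 1 3 (-1));
  (Zmx 25 (-3) (-33) 4, Zmx 3 1 (-4) (-1), Zmx 3 (-1) 1 0);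
  (Zmx 25 (-3) (-8) 1, Zmx 3 1 (-1) 0, Zmx 3 (-1) 1 0);
  (Zmx 25 9 (-14) (-5), Zmx 2 1 (-1) 0, Zmx 14 5 (-3) (-1));
  (Zmx 25 22 (-33) (-29), Zmx 3 1 (-4) (-1), Zmx 3 2 1 1);
  (Zmx 25 22 (-8) (-7), Zmx 3 1 (-1) 0, Zmx 3 2 1 1);
  (Zmx 26 (-7) (-11) 3, Zmx 7 (-2) (-3) 1, Zmx (-1) (-1) 1 0);
  (Zmx 26 7 (-15) (-4), Zmx 7 2 (-4) (-1), Zmx 4 1 (-1) 0);
  (Zmx 34 (-9) (-15) 4, Zmx 2 1 (-1) 0, Zmx (-5) 1 4 (-1));
  (Zmx 34 9 (-19) (-5), Zmx 2 1 (-1) 0, Zmx 19 5 (-4) (-1));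
  (Zmx (-15) (-13) (-8) (-7), Zmx 1 0 0 1, Zmx 25 22 (-8) (-7));
  (Zmx (-15) (-13) 7 6, Zmx 1 1 (-1) 0, Zmx 33 29 (-8) (-7));
  (Zmx (-15) (-2) (-7) (-1), Zmx 1 0 0 1, Zmx 20 3 (-7) (-1));
  (Zmx (-15) (-2) 8 1, Zmx 1 1 (-1) 0, Zmx 27 4 (-7) (-1));
  (Zmx (-15) 2 (-8) 1, Zmx 1 0 0 1, Zmx 25 (-3) (-8) 1);
  (Zmx (-15) 2 7 (-1), Zmx 1 1 (-1) 0, Zmx 33 (-4) (-8) 1);
  (Zmx (-15) 13 (-7) 6, Zmx 1 0 0 1, Zmx 20 (-17) (-7) 6);
  (Zmx (-15) 13 8 (-7), Zmx 1 1 (-1) 0, Zmx 27 (-23) (-7) 6);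
  (Zmx (-13) (-15) (-6) (-7), Zmx 1 0 0 1, Zmx 17 20 (-6) (-7));
  (Zmx (-13) (-15) 7 8, Zmx 1 1 (-1) 0, Zmx 23 27 (-6) (-7));
  (Zmx (-13) (-11) (-7) (-6), Zmx 1 0 0 1, Zmx 22 19 (-7) (-6));
  (Zmx (-13) (-11) 6 5, Zmx 1 1 (-1) 0, Zmx 29 25 (-7) (-6));
  (Zmx (-13) (-8) 5 3, Zmx 3 1 (-1) 0, Zmx (-5) (-3) 2 1);
  (Zmx (-13) (-5) (-5) (-2), Zmx 1 0 0 1, Zmx 12 5 (-5) (-2));
  (Zmx (-13) (-5) 8 3, Zmx 5 2 (-3) (-1), Zmx (-3) (-1) 1 0);
  (Zmx (-13) (-2) (-6) (-1), Zmx 1 0 0 1, Zmx 17 3 (-6) (-1));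
  (Zmx (-13) (-2) 7 1, Zmx 1 1 (-1) 0, Zmx 23 4 (-6) (-1));
  (Zmx (-13) 2 (-7) 1, Zmx 1 0 0 1, Zmx 22 (-3) (-7) 1);
  (Zmx (-13) 2 6 (-1), Zmx 1 1 (-1) 0, Zmx 29 (-4) (-7) 1);
  (Zmx (-13) 5 (-8) 3, Zmx 2 (-1) 1 0, Zmx 7 (-2) (-3) 1);
  (Zmx (-13) 5 5 (-2), Zmx 5 3 (-2) (-1), Zmx 3 1 (-1) 0);
  (Zmx (-13) 8 (-5) 3, Zmx 1 0 0 1, Zmx 12 (-7) (-5) 3);
  (Zmx (-13) 11 (-6) 5, Zmx 1 0 0 1, Zmx 17 (-14) (-6) 5);
  (Zmx (-13) 11 7 (-6), Zmx 1 1 (-1) 0, Zmx 23 (-19) (-6) 5);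
  (Zmx (-13) 15 (-7) 8, Zmx 1 0 0 1, Zmx 22 (-25) (-7) 8);
  (Zmx (-13) 15 6 (-7), Zmx 1 1 (-1) 0, Zmx 29 (-33) (-7) 8);
  (Zmx (-12) (-7) (-17) (-10), Zmx 2 (-1) 3 (-1), Zmx (-5) (-3) 2 1);
  (Zmx (-12) 17 7 (-10), Zmx 2 1 (-1) 0, Zmx (-7) 10 2 (-3));
  (Zmx (-11) (-13) (-5) (-6), Zmx 1 0 0 1, Zmx 14 17 (-5) (-6));
  (Zmx (-11) (-13) 6 7, Zmx 1 1 (-1) 0, Zmx 19 23 (-5) (-6));
  (Zmx (-11) (-9) (-6) (-5), Zmx 1 0 0 1, Zmx 19 16 (-6) (-5));
  (Zmx (-11) (-9) 5 4, Zmx 9 (-2) (-4) 1, Zmx (-1) (-1) 1 0);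
  (Zmx (-11) (-2) (-5) (-1), Zmx 1 0 0 1, Zmx 14 3 (-5) (-1));
  (Zmx (-11) (-2) 6 1, Zmx 2 1 (-1) 0, Zmx (-6) (-1) 1 0);
  (Zmx (-11) 2 (-6) 1, Zmx 1 0 0 1, Zmx 19 (-3) (-6) 1);
  (Zmx (-11) 2 5 (-1), Zmx 2 1 (-1) 0, Zmx 0 1 (-1) 0);
  (Zmx (-11) 9 (-5) 4, Zmx 1 0 0 1, Zmx 14 (-11) (-5) 4);
  (Zmx (-11) 9 6 (-5), Zmx 9 2 (-5) (-1), Zmx 4 1 (-1) 0);
  (Zmx (-11) 13 (-6) 7, Zmx 1 0 0 1, Zmx 19 (-22) (-6) 7);
  (Zmx (-11) 13 5 (-6), Zmx 1 1 (-1) 0, Zmx 25 (-29) (-6) 7);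
  (Zmx (-9) (-11) (-4) (-5), Zmx 1 0 0 1, Zmx 11 14 (-4) (-5));
  (Zmx (-9) (-11) 5 6, Zmx 2 1 (-1) 0, Zmx (-5) (-6) 1 1);
  (Zmx (-9) 11 (-5) 6, Zmx 1 0 0 1, Zmx 16 (-19) (-5) 6);
  (Zmx (-9) 11 4 (-5), Zmx 2 1 (-1) 0, Zmx 1 0 (-1) 1);
  (Zmx (-8) (-13) (-3) (-5), Zmx 1 0 0 1, Zmx 7 12 (-3) (-5));
  (Zmx (-8) (-13) 5 8, Zmx 3 2 (-2) (-1), Zmx 3 7 (-1) (-2));
  (Zmx (-8) (-3) (-13) (-5), Zmx 1 0 2 1, Zmx (-8) (-3) 3 1);
  (Zmx (-8) 13 (-5) 8, Zmx 1 (-1) 1 0, Zmx (-5) 8 3 (-5));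
  (Zmx (-8) 13 3 (-5), Zmx 3 1 (-1) 0, Zmx (-3) 5 1 (-2));
  (Zmx (-7) (-17) 5 12, Zmx 1 1 (-1) 0, Zmx 5 13 (-2) (-5));
  (Zmx (-7) 12 (-10) 17, Zmx 2 (-1) 3 (-1), Zmx (-3) 5 1 (-2));
  (Zmx (-7) 18 5 (-13), Zmx 7 3 (-5) (-2), Zmx (-1) 3 0 (-1));
  (Zmx (-5) (-13) (-3) (-8), Zmx 1 0 0 1, Zmx 10 27 (-3) (-8));
  (Zmx (-5) (-13) 2 5, Zmx 5 3 (-2) (-1), Zmx (-1) 3 0 (-1));
  (Zmx (-2) (-15) (-1) (-8), Zmx 1 0 0 1, Zmx 3 25 (-1) (-8));
  (Zmx (-2) (-15) 1 7, Zmx 1 1 (-1) 0, Zmx 4 33 (-1) (-8));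
  (Zmx (-2) (-13) (-1) (-7), Zmx 1 0 0 1, Zmx 3 22 (-1) (-7));
  (Zmx (-2) (-13) 1 6, Zmx 1 1 (-1) 0, Zmx 4 29 (-1) (-7));
  (Zmx (-2) (-11) (-1) (-6), Zmx 1 0 0 1, Zmx 3 19 (-1) (-6));
  (Zmx (-2) (-11) 1 5, Zmx 2 1 (-1) 0, Zmx (-1) 0 0 (-1));
  (Zmx 8 (-27) (-5) 17, Zmx 3 2 (-2) (-1), Zmx (-3) 8 1 (-3));
  (Zmx 8 (-13) 5 (-8), Zmx 1 (-1) 1 0, Zmx 5 (-8) (-3) 5);
  (Zmx 8 13 (-5) (-8), Zmx 8 (-3) (-5) 2, Zmx 1 (-3) 0 1);
  (Zmx 12 (-17) (-7) 10, Zmx 2 1 (-1) 0, Zmx 7 (-10) (-2) 3);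
  (Zmx 12 7 17 10, Zmx 2 (-1) 3 (-1), Zmx 5 3 (-2) (-1));
  (Zmx 13 (-8) (-8) 5, Zmx 5 2 (-3) (-1), Zmx 3 (-2) (-1) 1);
  (Zmx 13 8 8 5, Zmx 1 (-1) 1 0, Zmx 8 5 (-5) (-3));
  (Zmx (-13) (-8) (-8) (-5), Zmx 1 (-1) 1 0, Zmx (-8) (-5) 5 3);
  (Zmx (-13) 8 8 (-5), Zmx 5 2 (-3) (-1), Zmx (-3) 2 1 (-1))].

Definition certificate (n : nat) : seq zmx * seq pivot :=
  match n with
  | 1 => (generators_1, pivots_1)
  | 2 => (generators_2, pivots_2)
  | 3 => (generators_3, pivots_3)
  | 4 => (generators_4, pivots_4)
  | 5 => (generators_5, pivots_5)
  | _ => ([::], [::])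
  end.

Lemma certificates_valid :
  all (fun n => check_certificate n (certificate n).1 (certificate n).2) (iota 1 5).
Proof. by vm_compute. Qed.

Theorem proposition1 :
  forall n : nat, (1 <= n <= 5)%N -> quotient_fg (gr_pow n u_minus_1).
Proof.
move=> n n_range; apply: check_certificate_sound (allP certificates_valid n _).
by rewrite mem_iota; lia.
Qed.
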